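(* Let $N\ge 3$ and let $E,F\subset\bigcup_{k=1}^5S_k$. Then $S^{N-1}_{\mathbb R,E}\in\{S^{N-1}_{\mathbb R},S^{N-1}_{\mathbb R,*},S^{N-1}_{\mathbb R,+}\}$; in particular for any $\sigma\in S_k$ with $k\le5$ and $\sigma\ne1_k$, $S^{N-1}_{\mathbb R,\{\sigma\}}\in\{S^{N-1}_{\mathbb R},S^{N-1}_{\mathbb R,*}\}$. Likewise $\bar S^{N-1}_{\mathbb R,F}\in\{\bar S^{N-1}_{\mathbb R},\bar S^{N-1}_{\mathbb R,*},S^{N-1}_{\mathbb R,+}\}$, and the mixed sphere $S^{N-1}_{\mathbb R,E}\cap\bar S^{N-1}_{\mathbb R,F}$ is one of the nine spheres $S^{N-1}_{\mathbb R},S^{N-1}_{\mathbb R,*},S^{N-1}_{\mathbb R,+},S^{N-1,1}_{\mathbb R},S^{N-1,1}_{\mathbb R,*},\bar S^{N-1}_{\mathbb R,*},S^{N-1,0}_{\mathbb R},\bar S^{N-1,1}_{\mathbb R},\bar S^{N-1}_{\mathbb R}$.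
   Context: $C(S^{N-1}_{\mathbb R,+})$ denotes the universal $C^*$-algebra generated by self-adjoint elements $x_1,\dots,x_N$ subject to $\sum_i x_i^2=1$; subspaces are given by quotients by relations among the $x_i$, and intersections by imposing both sets of relations. Subspheres: $S^{N-1}_{\mathbb R}$: $x_ix_j=x_jx_i$ for all $i,j$; $\bar S^{N-1}_{\mathbb R}$: $x_ix_j=-x_jx_i$ for all $i\ne j$; $S^{N-1}_{\mathbb R,*}$: $x_ix_jx_k=x_kx_jx_i$ for all $i,j,k$; $\bar S^{N-1}_{\mathbb R,*}$: $x_ix_jx_k=-x_kx_jx_i$ for $i,j,k$ pairwise distinct and $x_ix_jx_k=x_kx_jx_i$ otherwise. Polygonal versions $S^{N-1,d-1}_{\mathbb R}$, $\bar S^{N-1,d-1}_{\mathbb R}$, $S^{N-1,d-1}_{\mathbb R,*}$ are obtained by additionally imposing $x_{i_0}\cdots x_{i_d}=0$ for pairwise distinct $i_0,\dots,i_d$. For $\sigma\in S_k$ and indices $i_1,\dots,i_k$, let $\varepsilon_\sigma(i)=(-1)^m$ with $m$ the number of pairs $r<s$ with $\sigma(r)>\sigma(s)$ and $i_{\sigma(r)}\ne i_{\sigma(s)}$. Untwisted relations $\mathcal R_\sigma$: $x_{i_1}\cdots x_{i_k}=x_{i_{\sigma(1)}}\cdots x_{i_{\sigma(k)}}$ for all indices; twisted relations $\bar{\mathcal R}_\sigma$: $x_{i_1}\cdots x_{i_k}=\varepsilon_\sigma(i)x_{i_{\sigma(1)}}\cdots x_{i_{\sigma(k)}}$ for all indices.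 For $E\subset\bigcup_kS_k$, $S^{N-1}_{\mathbb R,E}$ (resp. $\bar S^{N-1}_{\mathbb R,E}$) is the subsphere of $S^{N-1}_{\mathbb R,+}$ defined by $\mathcal R_\sigma$ (resp. $\bar{\mathcal R}_\sigma$), $\sigma\in E$. *)

From Stdlib Require Import Reals List Arith Bool.
Import ListNotations.

Definition C : Type := (R * R)%type.
Definition Cadd (a b : C) : C := (fst a + fst b, snd a + snd b)%R.
Definition Cmul (a b : C) : C :=
  (fst a * fst b - snd a * snd b, fst a * snd b + snd a * fst b)%R.
Definition Cconj (a : C) : C := (fst a, - snd a)%R.
Definition Cmod (a : C) : R := sqrt (fst a * fst a + snd a * snd a)%R.
Definition C1 : C := (1%R, 0%R).

Record CStarAlg := {
  car :> Type;
  c0 : car; c1 : car;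
  cadd : car -> car -> car; copp : car -> car; cmul : car -> car -> car;
  csc : C -> car -> car; cstar : car -> car; cnorm : car -> R;
  addA : forall x y z, cadd x (cadd y z) = cadd (cadd x y) z;
  addC : forall x y, cadd x y = cadd y x;
  add0 : forall x, cadd c0 x = x;
  addN : forall x, cadd (copp x) x = c0;
  mulA : forall x y z, cmul x (cmul y z) = cmul (cmul x y) z;
  mul1l : forall x, cmul c1 x = x;
  mul1r : forall x, cmul x c1 = x;
  mulDl : forall x y z, cmul (cadd x y) z = cadd (cmul x z) (cmul y z);
  mulDr : forall x y z, cmul x (cadd y z) = cadd (cmul x y) (cmul x z);
  scA : forall a b x, csc a (csc b x) = csc (Cmul a b) x;
  sc1 : forall x, csc C1 x = x;
  scDl : forall a b x, csc (Cadd a b) x = cadd (csc a x) (csc b x);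
  scDr : forall a x y, csc a (cadd x y) = cadd (csc a x) (csc a y);
  scMl : forall a x y, cmul (csc a x) y = csc a (cmul x y);
  scMr : forall a x y, cmul x (csc a y) = csc a (cmul x y);
  starK : forall x, cstar (cstar x) = x;
  starD : forall x y, cstar (cadd x y) = cadd (cstar x) (cstar y);
  starM : forall x y, cstar (cmul x y) = cmul (cstar y) (cstar x);
  starZ : forall a x, cstar (csc a x) = csc (Cconj a) (cstar x);
  norm_eq0 : forall x, cnorm x = 0%R -> x = c0;
  normD : forall x y, (cnorm (cadd x y) <= cnorm x + cnorm y)%R;
  normZ : forall a x, cnorm (csc a x) = (Cmod a * cnorm x)%R;
  normM : forall x y, (cnorm (cmul x y) <= cnorm x * cnorm y)%R;
  norm_cstar : forall x, cnorm (cmul (cstar x) x) = (cnorm x * cnorm x)%R;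
  complete : forall u : nat -> car,
    (forall eps, (0 < eps)%R -> exists M, forall m n, (M <= m)%nat -> (M <= n)%nat ->
        (cnorm (cadd (u m) (copp (u n))) < eps)%R) ->
    exists l, forall eps, (0 < eps)%R -> exists M, forall n, (M <= n)%nat ->
        (cnorm (cadd (u n) (copp l)) < eps)%R
}.

Arguments c0 {_}. Arguments c1 {_}. Arguments cadd {_}. Arguments copp {_}.
Arguments cmul {_}. Arguments cstar {_}.

Definition mprod {A : CStarAlg} (l : list (car A)) : car A := fold_right cmul c1 l.
Definition msum {A : CStarAlg} (l : list (car A)) : car A := fold_right cadd c0 l.

Definition rels : Type := forall A : CStarAlg, (nat -> car A) -> Prop.

Definition sphere_pt (N : nat) (A : CStarAlg) (x : nat -> car A) : Prop :=
  (forall i, (i < N)%nat -> cstar (x i) = x i) /\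
  msum (map (fun i => cmul (x i) (x i)) (seq 0 N)) = c1.

(* Two subspheres (quotients of C(S^{N-1}_{R,+}) by the relations) coincide
   iff the relations are equivalent for every sphere point in every C*-algebra
   (universal property). *)
Definition sph_eq (N : nat) (P Q : rels) : Prop :=
  forall (A : CStarAlg) (x : nat -> car A), sphere_pt N A x -> (P A x <-> Q A x).

Definition rels_and (P Q : rels) : rels := fun A x => P A x /\ Q A x.
Definition free_rels : rels := fun _ _ => True.

Definition is_perm (k : nat) (s : nat -> nat) : Prop :=
  (forall r, (r < k)%nat -> (s r < k)%nat) /\
  (forall r r', (r < k)%nat -> (r' < k)%nat -> s r = s r' -> r = r').

(* sign epsilon_sigma(i) : (-1)^m, m = #{r<s : sigma r > sigma s, i_{sigma r} <> i_{sigma s}} *)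
Definition inv_count (k : nat) (s i : nat -> nat) : nat :=
  length (filter (fun p : nat * nat =>
            (fst p <? snd p) && (s (snd p) <? s (fst p)) && negb (i (s (fst p)) =? i (s (snd p))))
          (list_prod (seq 0 k) (seq 0 k))).

Definition sgn {A : CStarAlg} (b : bool) (a : car A) : car A := if b then copp a else a.

Definition indices_ok (N k : nat) (i : nat -> nat) : Prop := forall r, (r < k)%nat -> (i r < N)%nat.

Definition R_sigma (N k : nat) (s : nat -> nat) : rels := fun A x =>
  forall i, indices_ok N k i ->
    mprod (map (fun r => x (i r)) (seq 0 k)) = mprod (map (fun r => x (i (s r))) (seq 0 k)).

Definition Rbar_sigma (N k : nat) (s : nat -> nat) : rels := fun A x =>
  forall i, indices_ok N k i ->
    mprod (map (fun r => x (i r)) (seq 0 k)) =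
    sgn (Nat.odd (inv_count k s i)) (mprod (map (fun r => x (i (s r))) (seq 0 k))).

Definition permset : Type := nat -> (nat -> nat) -> Prop.
Definition S_E (N : nat) (E : permset) : rels := fun A x =>
  forall k s, E k s -> R_sigma N k s A x.
Definition Sbar_F (N : nat) (F : permset) : rels := fun A x =>
  forall k s, F k s -> Rbar_sigma N k s A x.
Definition single (k0 : nat) (s0 : nat -> nat) : permset := fun k s => k = k0 /\ s = s0.

Definition classical (N : nat) : rels := fun A x =>
  forall i j, (i < N)%nat -> (j < N)%nat -> cmul (x i) (x j) = cmul (x j) (x i).
Definition anticomm (N : nat) : rels := fun A x =>
  forall i j, (i < N)%nat -> (j < N)%nat -> i <> j -> cmul (x i) (x j) = copp (cmul (x j) (x i)).
Definition halflib (N : nat) : rels := fun A x =>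
  forall i j k, (i < N)%nat -> (j < N)%nat -> (k < N)%nat ->
    cmul (x i) (cmul (x j) (x k)) = cmul (x k) (cmul (x j) (x i)).
Definition halflib_bar (N : nat) : rels := fun A x =>
  forall i j k, (i < N)%nat -> (j < N)%nat -> (k < N)%nat ->
    cmul (x i) (cmul (x j) (x k)) =
    sgn (negb (i =? j) && negb (j =? k) && negb (i =? k)) (cmul (x k) (cmul (x j) (x i))).
Definition poly0 (N : nat) : rels := fun A x =>
  forall i j, (i < N)%nat -> (j < N)%nat -> i <> j -> cmul (x i) (x j) = c0.
Definition poly1 (N : nat) : rels := fun A x =>
  forall i j k, (i < N)%nat -> (j < N)%nat -> (k < N)%nat -> i <> j -> j <> k -> i <> k ->
    cmul (x i) (cmul (x j) (x k)) = c0.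

From Stdlib Require Import Reals List Arith Bool Lia Permutation Classical.
Import ListNotations.

(* Each relation R_sigma, sigma in S_k, and its twisted version is a signed identity between a
   word x_{i_1} ... x_{i_k} and its permutation. Such identities can be derived from each other
   by relabelling variables, symmetry, transitivity, the involution (the x_i are self-adjoint),
   multiplication by a fresh letter, and contraction of a square x_v x_v of a fresh letter v,
   which sums to 1 over v on the sphere. For every non-identity sigma with k <= 5 we exhibit
   derivations, checked by computation, showing that R_sigma is equivalent to commutation
   x_i x_j = x_j x_i or to half-commutation x_i x_j x_k = x_k x_j x_i, uniformly in the twist;
   as commutation implies half-commutation, a family of such relations is equivalent to its
   strongest member. For the mixed spheres, a relation holding with both signs forces the
   product to vanish, 2 being invertible. *)

Section CStarAlgebraIdentities.
Variable A : CStarAlg.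
Implicit Types (x y z : car A) (l : list (car A)).

Lemma addr0 x : cadd x c0 = x.
Proof. rewrite addC; apply add0. Qed.

Lemma addrN x : cadd x (copp x) = c0.
Proof. rewrite addC; apply addN. Qed.

Lemma addr_eq0 x y : cadd x y = c0 -> x = copp y.
Proof. intro H. rewrite <- (addr0 x), <- (addrN y), addA, H. apply add0. Qed.

Lemma opprK x : copp (copp x) = x.
Proof. symmetry; apply addr_eq0, addrN. Qed.

Lemma oppr0 : copp (@c0 A) = c0.
Proof. symmetry; apply addr_eq0, add0. Qed.

Lemma opprD x y : copp (cadd x y) = cadd (copp x) (copp y).
Proof.
  symmetry; apply addr_eq0.
  rewrite <- addA, (addC _ x y), (addA _ (copp y) y x), addN, add0. apply addN.
Qed.

Lemma double_eq x : x = cadd x x -> x = c0.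
Proof. intro H. rewrite <- (addrN x). rewrite H at 2. rewrite <- addA, addrN, addr0. reflexivity. Qed.

Lemma mul0r x : cmul c0 x = c0.
Proof. apply double_eq. rewrite <- mulDl, add0. reflexivity. Qed.

Lemma mulr0 x : cmul x c0 = c0.
Proof. apply double_eq. rewrite <- mulDr, add0. reflexivity. Qed.

Lemma mulNr x y : cmul (copp x) y = copp (cmul x y).
Proof. apply addr_eq0. rewrite <- mulDl, addN. apply mul0r. Qed.

Lemma mulrN x y : cmul x (copp y) = copp (cmul x y).
Proof. apply addr_eq0. rewrite <- mulDr, addN. apply mulr0. Qed.

Lemma star0 : cstar (@c0 A) = c0.
Proof. apply double_eq. rewrite <- starD, add0. reflexivity. Qed.

Lemma starN x : cstar (copp x) = copp (cstar x).
Proof. apply addr_eq0. rewrite <- starD, addN. apply star0. Qed.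

Lemma star1 : cstar (@c1 A) = c1.
Proof.
  assert (H : cstar (cmul (@c1 A) (cstar c1)) = cstar c1) by (rewrite starM, starK; apply mul1l).
  rewrite mul1l, starK in H. symmetry; exact H.
Qed.

Lemma scaler0 a : csc A a c0 = c0.
Proof. apply double_eq. rewrite <- scDr, add0. reflexivity. Qed.

(* The only place where the complex scalars matter: 2 is invertible. *)
Lemma eq_oppr_eq0 x : x = copp x -> x = c0.
Proof.
  intro H.
  assert (Hhalf : Cmul (1/2, 0)%R (Cadd C1 C1) = C1).
  { unfold Cmul, Cadd, C1; simpl. f_equal; field. }
  rewrite <- (sc1 A x), <- Hhalf, <- scA, scDl, sc1.
  rewrite H at 1. rewrite addN. apply scaler0.
Qed.

Lemma eq_and_eq_oppr_eq0 x y : x = y -> x = copp y -> x = c0.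
Proof. intros E1 E2. apply eq_oppr_eq0. rewrite E2 at 1. rewrite <- E1. reflexivity. Qed.

Lemma sgn_xor b1 b2 x : sgn b1 (sgn b2 x) = sgn (xorb b1 b2) x.
Proof. destruct b1, b2; simpl; rewrite ?opprK; reflexivity. Qed.

Lemma mul_sgnl b x y : cmul (sgn b x) y = sgn b (cmul x y).
Proof. destruct b; [apply mulNr | reflexivity]. Qed.

Lemma mul_sgnr b x y : cmul x (sgn b y) = sgn b (cmul x y).
Proof. destruct b; [apply mulrN | reflexivity]. Qed.

Lemma star_sgn b x : cstar (sgn b x) = sgn b (cstar x).
Proof. destruct b; [apply starN | reflexivity]. Qed.

Lemma msum_sgn b (f : nat -> car A) (js : list nat) :
  msum (map (fun j => sgn b (f j)) js) = sgn b (msum (map f js)).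
Proof.
  destruct b; simpl; [|reflexivity]. induction js as [|j js IH]; simpl.
  - symmetry; apply oppr0.
  - rewrite IH, opprD. reflexivity.
Qed.

Lemma msum_mul x y (f : nat -> car A) (js : list nat) :
  msum (map (fun j => cmul x (cmul (f j) y)) js) = cmul x (cmul (msum (map f js)) y).
Proof.
  induction js as [|j js IH]; simpl.
  - rewrite mul0r, mulr0. reflexivity.
  - unfold msum in *. simpl. rewrite IH, <- mulDr, <- mulDl. reflexivity.
Qed.

Lemma mprod_cat l1 l2 : mprod (l1 ++ l2) = cmul (mprod l1) (mprod l2).
Proof.
  induction l1 as [|y l1 IH]; simpl.
  - symmetry; apply mul1l.
  - unfold mprod in *. simpl. rewrite IH. apply mulA.
Qed.

Lemma star_mprod l : (forall y, In y l -> cstar y = y) -> cstar (mprod l) = mprod (rev l).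
Proof.
  induction l as [|y l IH]; intro Hsa; simpl.
  - apply star1.
  - unfold mprod at 1; simpl. rewrite starM. fold (mprod l).
    rewrite IH, (Hsa y (or_introl eq_refl)), mprod_cat by (intros; apply Hsa; right; auto).
    unfold mprod at 3; simpl. rewrite mul1r. reflexivity.
Qed.

End CStarAlgebraIdentities.

Definition distinct_at (i : nat -> nat) (pr : nat * nat) : bool := negb (i (fst pr) =? i (snd pr)).

Definition parity (D : list (nat * nat)) (i : nat -> nat) : bool :=
  Nat.odd (length (filter (distinct_at i) D)).

Lemma parity_cons pr D i : parity (pr :: D) i = xorb (distinct_at i pr) (parity D i).
Proof.
  unfold parity; simpl. destruct (distinct_at i pr); simpl; [|reflexivity].
  rewrite Nat.odd_succ, <- Nat.negb_odd. reflexivity.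
Qed.

Lemma parity_app D1 D2 i : parity (D1 ++ D2) i = xorb (parity D1 i) (parity D2 i).
Proof.
  induction D1 as [|pr D1 IH]; simpl; [reflexivity|].
  rewrite !parity_cons, IH. symmetry; apply xorb_assoc.
Qed.

Lemma parity_perm D D' i : Permutation D D' -> parity D i = parity D' i.
Proof.
  induction 1; rewrite ?parity_cons; try congruence.
  destruct (distinct_at i x), (distinct_at i y); reflexivity.
Qed.

Lemma parity_map g D i :
  parity (map (fun pr => (g (fst pr), g (snd pr))) D) i = parity D (fun v => i (g v)).
Proof. induction D; simpl; rewrite ?parity_cons, ?IHD; reflexivity. Qed.

Lemma parity_ext D i j :
  (forall pr, In pr D -> i (fst pr) = j (fst pr) /\ i (snd pr) = j (snd pr)) ->
  parity D i = parity D j.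
Proof.
  induction D as [|pr D IH]; intro Hij; simpl; [reflexivity|].
  rewrite !parity_cons, IH by (intros; apply Hij; right; auto).
  destruct (Hij pr (or_introl eq_refl)) as [E1 E2]. unfold distinct_at. rewrite E1, E2. reflexivity.
Qed.

Definition pair_eq_dec (p q : nat * nat) : {p = q} + {p <> q}.
Proof. decide equality; apply Nat.eq_dec. Defined.

Fixpoint remove_one (p : nat * nat) (D : list (nat * nat)) : list (nat * nat) :=
  match D with
  | [] => []
  | q :: D' => if pair_eq_dec p q then D' else q :: remove_one p D'
  end.

Lemma remove_one_perm p D : In p D -> Permutation D (p :: remove_one p D).
Proof.
  induction D as [|q D IH]; simpl; [contradiction|].
  destruct (pair_eq_dec p q) as [<-|Hpq]; [auto|].
  intros [->|Hin]; [congruence|].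
  eapply perm_trans; [apply perm_skip, IH, Hin | apply perm_swap].
Qed.

Definition toggle (p : nat * nat) (D : list (nat * nat)) : list (nat * nat) :=
  if in_dec pair_eq_dec p D then remove_one p D else p :: D.

Lemma parity_toggle p D i : parity (toggle p D) i = xorb (distinct_at i p) (parity D i).
Proof.
  unfold toggle. destruct (in_dec pair_eq_dec p D) as [Hin|]; [|apply parity_cons].
  rewrite (parity_perm _ _ i (remove_one_perm _ _ Hin)), parity_cons.
  destruct (distinct_at i p), (parity (remove_one p D) i); reflexivity.
Qed.

(* Only the parity of a list of pairs matters: [normalize] drops diagonal pairs, orders each
   pair and cancels repeated pairs, so that equal parities can be recognised up to order. *)
Definition orient (p : nat * nat) : nat * nat := if fst p <=? snd p then p else (snd p, fst p).

Definition normalize (D : list (nat * nat)) : list (nat * nat) :=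
  fold_right toggle [] (map orient (filter (fun p => negb (fst p =? snd p)) D)).

Lemma parity_normalize D i : parity (normalize D) i = parity D i.
Proof.
  unfold normalize. induction D as [|p D IH]; simpl; [reflexivity|].
  rewrite parity_cons. destruct (Nat.eqb_spec (fst p) (snd p)) as [E|E]; simpl.
  - rewrite IH. unfold distinct_at. rewrite E, Nat.eqb_refl. reflexivity.
  - rewrite parity_toggle, IH. unfold orient, distinct_at.
    destruct (fst p <=? snd p); simpl; rewrite ?(Nat.eqb_sym (i (snd p))); reflexivity.
Qed.

Fixpoint perm_eqb (D1 D2 : list (nat * nat)) : bool :=
  match D1 with
  | [] => match D2 with [] => true | _ => false end
  | p :: D1' => if in_dec pair_eq_dec p D2 then perm_eqb D1' (remove_one p D2) else false
  end.

Lemma perm_eqb_perm D1 D2 : perm_eqb D1 D2 = true -> Permutation D1 D2.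
Proof.
  revert D2; induction D1 as [|p D1 IH]; intros D2 H; simpl in H.
  - destruct D2; [auto | discriminate].
  - destruct (in_dec pair_eq_dec p D2) as [Hin|]; [|discriminate].
    eapply perm_trans; [apply perm_skip, IH, H | symmetry; apply remove_one_perm, Hin].
Qed.

(* [WordRel n L P D] stands for the identity x_{i(L)} = ± x_{i(P)} for all assignments [i] of the
   [n] variables to generators; in the twisted reading the sign is [-1] raised to the number of
   pairs of [D] that [i] sends to distinct generators, in the untwisted reading it is [+1]. *)
Record word_rel := WordRel { arity : nat; lhs : list nat; rhs : list nat; pairs : list (nat * nat) }.

Definition word {A : CStarAlg} (x : nat -> car A) (w : list nat) : car A := mprod (map x w).

Definition holds (N : nat) (twisted : bool) {A : CStarAlg} (x : nat -> car A) (r : word_rel) :=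
  forall i, (forall v, v < arity r -> i v < N) ->
    word x (map i (lhs r)) = sgn (twisted && parity (pairs r) i) (word x (map i (rhs r))).

Definition relabel (n : nat) (g : list nat) (r : word_rel) : word_rel :=
  WordRel n (map (fun v => nth v g 0) (lhs r)) (map (fun v => nth v g 0) (rhs r))
    (normalize (map (fun pr => (nth (fst pr) g 0, nth (snd pr) g 0)) (pairs r))).

Definition rel_sym (r : word_rel) : word_rel := WordRel (arity r) (rhs r) (lhs r) (pairs r).

Definition rel_trans (r1 r2 : word_rel) : word_rel :=
  WordRel (arity r1) (lhs r1) (rhs r2) (normalize (pairs r1 ++ pairs r2)).

Definition rel_rev (r : word_rel) : word_rel :=
  WordRel (arity r) (rev (lhs r)) (rev (rhs r)) (pairs r).

Definition rel_mulr (r : word_rel) : word_rel :=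
  WordRel (S (arity r)) (lhs r ++ [arity r]) (rhs r ++ [arity r]) (pairs r).

Definition rel_mull (r : word_rel) : word_rel :=
  WordRel (S (arity r)) (arity r :: lhs r) (arity r :: rhs r) (pairs r).

Section Derivation.
Variables (N : nat) (twisted : bool) (A : CStarAlg) (x : nat -> car A).
Hypothesis sphere : sphere_pt N A x.
Local Notation holds := (holds N twisted x).

Lemma word_cat w1 w2 : word x (w1 ++ w2) = cmul (word x w1) (word x w2).
Proof. unfold word. rewrite map_app. apply mprod_cat. Qed.

Lemma star_word w : (forall v, In v w -> v < N) -> cstar (word x w) = word x (rev w).
Proof.
  intro Hw. unfold word. rewrite star_mprod, map_rev; [reflexivity|].
  intros y Hy. apply in_map_iff in Hy as [v [<- Hv]]. apply (proj1 sphere), Hw, Hv.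
Qed.

Lemma holds_refl n w : holds (WordRel n w w []).
Proof. intros i _. simpl. rewrite andb_false_r. reflexivity. Qed.

Lemma holds_relabel n g r :
  (forall v, v < arity r -> nth v g 0 < n) -> holds r -> holds (relabel n g r).
Proof.
  intros Hg H i Hi. simpl. rewrite parity_normalize, (parity_map (fun v => nth v g 0)), !map_map.
  apply (H (fun v => i (nth v g 0))). intros v Hv. apply Hi, Hg, Hv.
Qed.

Lemma holds_sym r : holds r -> holds (rel_sym r).
Proof. intros H i Hi. simpl. rewrite (H i Hi), sgn_xor, xorb_nilpotent. reflexivity. Qed.

Lemma holds_trans r1 r2 :
  arity r1 = arity r2 -> rhs r1 = lhs r2 -> holds r1 -> holds r2 -> holds (rel_trans r1 r2).
Proof.
  intros En Ew H1 H2 i Hi. simpl in *.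
  rewrite parity_normalize, parity_app, (H1 i Hi), Ew, (H2 i), sgn_xor by (rewrite <- En; auto).
  destruct twisted; reflexivity.
Qed.

Lemma holds_rev r : (forall v, In v (lhs r ++ rhs r) -> v < arity r) -> holds r -> holds (rel_rev r).
Proof.
  intros Hv H i Hi. simpl.
  assert (Hw : forall w, (forall v, In v w -> In v (lhs r ++ rhs r)) ->
            forall u, In u (map i w) -> u < N).
  { intros w Hsub u Hu. apply in_map_iff in Hu as [v [<- Hvw]]. apply Hi, Hv, Hsub, Hvw. }
  rewrite !map_rev, <- !star_word, (H i Hi), star_sgn by (apply Hw; intros; apply in_or_app; auto).
  reflexivity.
Qed.

Lemma holds_mulr r : holds r -> holds (rel_mulr r).
Proof.
  intros H i Hi. simpl in *. rewrite !map_app, !word_cat, (H i), mul_sgnl; [reflexivity|].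
  intros v Hv. apply Hi. lia.
Qed.

Lemma holds_mull r : holds r -> holds (rel_mull r).
Proof.
  intros H i Hi. simpl in *.
  change (cmul (x (i (arity r))) (word x (map i (lhs r))) =
          sgn (twisted && parity (pairs r) i) (cmul (x (i (arity r))) (word x (map i (rhs r))))).
  rewrite (H i), mul_sgnr; [reflexivity|]. intros v Hv. apply Hi. lia.
Qed.

(* The letter [v] occurs only in the two squares [v v]: summing the identity over the value [j]
   of [v] turns each [x_j x_j] into [sum_j x_j^2 = 1]. *)
Lemma holds_contract n L1 L2 P1 P2 D v :
  ~ In v (L1 ++ L2 ++ P1 ++ P2) ->
  (forall pr, In pr D -> fst pr <> v /\ snd pr <> v) ->
  holds (WordRel n (L1 ++ v :: v :: L2) (P1 ++ v :: v :: P2) D) ->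
  holds (WordRel n (L1 ++ L2) (P1 ++ P2) D).
Proof.
  intros Hfresh HD H i Hi. simpl in *.
  set (ij := fun j t => if t =? v then j else i t).
  assert (Hoff : forall j w, ~ In v w -> map (ij j) w = map i w).
  { intros j w Hw. apply map_ext_in. intros t Ht. unfold ij.
    destruct (Nat.eqb_spec t v) as [->|]; [contradiction | reflexivity]. }
  assert (Hsquare : forall j w1 w2, ~ In v w1 -> ~ In v w2 ->
      word x (map (ij j) (w1 ++ v :: v :: w2)) =
      cmul (word x (map i w1)) (cmul (cmul (x j) (x j)) (word x (map i w2)))).
  { intros j w1 w2 H1 H2. rewrite map_app, word_cat, (Hoff j w1) by auto. simpl.
    replace (ij j v) with j by (unfold ij; rewrite Nat.eqb_refl; reflexivity).
    rewrite (Hoff j w2) by auto. unfold word, mprod; simpl. rewrite (mulA _ (x j) (x j)). reflexivity. }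
  assert (Hsign : forall j, parity D (ij j) = parity D i).
  { intro j. apply parity_ext. intros pr Hpr. destruct (HD pr Hpr) as [E1 E2]. unfold ij.
    apply Nat.eqb_neq in E1, E2. rewrite E1, E2. auto. }
  assert (Hj : forall j, j < N ->
      cmul (word x (map i L1)) (cmul (cmul (x j) (x j)) (word x (map i L2))) =
      sgn (twisted && parity D i)
        (cmul (word x (map i P1)) (cmul (cmul (x j) (x j)) (word x (map i P2))))).
  { intros j Hj. rewrite <- !Hsquare, <- (Hsign j) by (rewrite ?in_app_iff in Hfresh; tauto).
    apply H. intros t Ht. unfold ij. destruct (t =? v); auto. }
  assert (Hunit : forall y z, cmul y z =
      msum (map (fun j => cmul y (cmul (cmul (x j) (x j)) z)) (seq 0 N))).
  { intros y z. rewrite msum_mul, (proj2 sphere), mul1l. reflexivity. }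
  rewrite !map_app, !word_cat, Hunit, (Hunit (word x (map i P1))), <- msum_sgn.
  f_equal. apply map_ext_in. intros j Hjs. apply in_seq in Hjs. apply Hj. lia.
Qed.

End Derivation.

(* A derivation step appends a new relation to the list of relations derived so far; the
   arguments [a] and [c] refer to earlier relations by position, and [SContr a v q1 q2] contracts
   the squares [v v] starting at position [q1] of the left and [q2] of the right side. *)
Inductive step :=
| SRefl (n : nat) (w : list nat)
| SRelabel (a n : nat) (g : list nat)
| SSym (a : nat)
| STrans (a c : nat)
| SStar (a : nat)
| SMulR (a : nat)
| SMulL (a : nat)
| SContr (a v q1 q2 : nat).

Definition empty_rel : word_rel := WordRel 0 [] [] [].

Definition contract (v q1 q2 : nat) (r : word_rel) : option word_rel :=
  let L1 := firstn q1 (lhs r) in let L2 := skipn (S (S q1)) (lhs r) in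
  let P1 := firstn q2 (rhs r) in let P2 := skipn (S (S q2)) (rhs r) in
  if list_eq_dec Nat.eq_dec (lhs r) (L1 ++ v :: v :: L2) then
  if list_eq_dec Nat.eq_dec (rhs r) (P1 ++ v :: v :: P2) then
  if in_dec Nat.eq_dec v (L1 ++ L2 ++ P1 ++ P2) then None else
  if forallb (fun pr => negb (fst pr =? v) && negb (snd pr =? v)) (pairs r)
  then Some (WordRel (arity r) (L1 ++ L2) (P1 ++ P2) (pairs r)) else None
  else None else None.

Definition apply_step (rs : list word_rel) (s : step) : option word_rel :=
  match s with
  | SRefl n w => Some (WordRel n w w [])
  | SRelabel a n g =>
      let r := nth a rs empty_rel in
      if forallb (fun v => nth v g 0 <? n) (seq 0 (arity r)) then Some (relabel n g r) else None
  | SSym a => Some (rel_sym (nth a rs empty_rel))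
  | STrans a c =>
      let r1 := nth a rs empty_rel in let r2 := nth c rs empty_rel in
      if Nat.eq_dec (arity r1) (arity r2) then
      if list_eq_dec Nat.eq_dec (rhs r1) (lhs r2) then Some (rel_trans r1 r2) else None
      else None
  | SStar a =>
      let r := nth a rs empty_rel in
      if forallb (fun v => v <? arity r) (lhs r ++ rhs r) then Some (rel_rev r) else None
  | SMulR a => Some (rel_mulr (nth a rs empty_rel))
  | SMulL a => Some (rel_mull (nth a rs empty_rel))
  | SContr a v q1 q2 => contract v q1 q2 (nth a rs empty_rel)
  end.

Fixpoint run (rs : list word_rel) (ss : list step) : option (list word_rel) :=
  match ss with
  | [] => Some rs
  | s :: ss' => match apply_step rs s with Some r => run (rs ++ [r]) ss' | None => None end
  end.

Definition list_nat_eqb (w w' : list nat) : bool :=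
  if list_eq_dec Nat.eq_dec w w' then true else false.

Lemma list_nat_eqb_eq w w' : list_nat_eqb w w' = true -> w = w'.
Proof. unfold list_nat_eqb. destruct (list_eq_dec Nat.eq_dec w w'); congruence. Qed.

Definition same_rel (r t : word_rel) : bool :=
  (arity r =? arity t) && list_nat_eqb (lhs r) (lhs t) && list_nat_eqb (rhs r) (rhs t)
  && perm_eqb (normalize (pairs r)) (normalize (pairs t)).

Definition entails (rs : list word_rel) (target : word_rel) (cert : list step) : bool :=
  match run rs cert with
  | Some rs' => existsb (fun r => same_rel r target) rs'
  | None => false
  end.

Section Soundness.
Variables (N : nat) (twisted : bool) (A : CStarAlg) (x : nat -> car A).
Hypothesis sphere : sphere_pt N A x.
Local Notation holds := (holds N twisted x).

Lemma holds_nth rs a : Forall holds rs -> holds (nth a rs empty_rel).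
Proof.
  intro Hrs. revert a. induction Hrs as [|r rs Hr _ IH]; intros [|a]; simpl; auto.
  all: apply holds_refl.
Qed.

Lemma holds_contract_step v q1 q2 r r' : holds r -> contract v q1 q2 r = Some r' -> holds r'.
Proof.
  unfold contract. destruct r as [n L P D]; simpl.
  destruct (list_eq_dec _ L _) as [EL|]; [|discriminate].
  destruct (list_eq_dec _ P _) as [EP|]; [|discriminate].
  destruct (in_dec _ _ _) as [|Hfresh]; [discriminate|].
  destruct (forallb _ D) eqn:HD; [|discriminate].
  intros H [= <-]. rewrite EL, EP in H. apply (holds_contract N twisted A x sphere _ _ _ _ _ _ v);
    auto.
  intros pr Hpr. rewrite forallb_forall in HD. specialize (HD pr Hpr).
  apply andb_true_iff in HD as [E1 E2]. apply negb_true_iff, Nat.eqb_neq in E1, E2. auto.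
Qed.

Lemma apply_step_sound rs s r : Forall holds rs -> apply_step rs s = Some r -> holds r.
Proof.
  intros Hrs Hs. pose proof (holds_nth rs) as Hnth.
  destruct s as [n w|a n g|a|a c|a|a|a|a v q1 q2]; simpl in Hs.
  - injection Hs as <-. apply holds_refl.
  - destruct (forallb _ _) eqn:Hg; [|discriminate]. injection Hs as <-.
    apply holds_relabel, Hnth, Hrs. intros v Hv. rewrite forallb_forall in Hg.
    apply Nat.ltb_lt, Hg, in_seq. lia.
  - injection Hs as <-. apply holds_sym, Hnth, Hrs.
  - destruct (Nat.eq_dec _ _); [|discriminate]. destruct (list_eq_dec _ _ _); [|discriminate].
    injection Hs as <-. apply holds_trans; auto.
  - destruct (forallb _ _) eqn:Hv; [|discriminate]. injection Hs as <-.
    apply holds_rev; auto. rewrite forallb_forall in Hv. intros v Hin. apply Nat.ltb_lt, Hv, Hin.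
  - injection Hs as <-. apply holds_mulr, Hnth, Hrs.
  - injection Hs as <-. apply holds_mull, Hnth, Hrs.
  - eapply holds_contract_step; eauto.
Qed.

Lemma run_sound ss : forall rs rs', Forall holds rs -> run rs ss = Some rs' -> Forall holds rs'.
Proof.
  induction ss as [|s ss IH]; intros rs rs' Hrs Hrun; simpl in Hrun.
  - congruence.
  - destruct (apply_step rs s) as [r|] eqn:Hs; [|discriminate].
    apply (IH (rs ++ [r])); auto. apply Forall_app. split; auto.
    constructor; [eapply apply_step_sound; eauto | constructor].
Qed.

Lemma holds_same_rel r t : holds r -> same_rel r t = true -> holds t.
Proof.
  destruct r as [n L P D], t as [n' L' P' D']; unfold same_rel; simpl.
  intros H Hm. apply andb_true_iff in Hm as [Hm Hp]. apply andb_true_iff in Hm as [Hm HP].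
  apply andb_true_iff in Hm as [Hn HL].
  apply Nat.eqb_eq in Hn. apply list_nat_eqb_eq in HL, HP. subst.
  intros i Hi. red in H. simpl in *. rewrite (H i Hi), <- (parity_normalize D), <- (parity_normalize D').
  rewrite (parity_perm _ _ i (perm_eqb_perm _ _ Hp)). reflexivity.
Qed.

Lemma entails_sound rs target cert : Forall holds rs -> entails rs target cert = true -> holds target.
Proof.
  unfold entails. intros Hrs Hc. destruct (run rs cert) as [rs'|] eqn:Hrun; [|discriminate].
  apply existsb_exists in Hc as [r [Hin Hm]].
  pose proof (run_sound cert rs rs' Hrs Hrun) as Hrs'. rewrite Forall_forall in Hrs'.
  eapply holds_same_rel; eauto.
Qed.

End Soundness.

(* The relation R_p of a permutation [p] of [0 .. k-1], listed as [p 0, ..., p (k-1)]: its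
   pairs are the inversions of [p], named by their letters. *)
Definition inversion_pairs (p : list nat) : list (nat * nat) :=
  map (fun pr => (nth (fst pr) p 0, nth (snd pr) p 0))
    (filter (fun pr => (fst pr <? snd pr) && (nth (snd pr) p 0 <? nth (fst pr) p 0))
       (list_prod (seq 0 (length p)) (seq 0 (length p)))).

Definition perm_rel (p : list nat) : word_rel :=
  WordRel (length p) (seq 0 (length p)) p (inversion_pairs p).

Definition comm_rel : word_rel := perm_rel [1; 0].
Definition halfcomm_rel : word_rel := perm_rel [2; 1; 0].

Inductive kind := Comm | HalfComm.

Definition kind_rel (c : kind) : word_rel :=
  match c with Comm => comm_rel | HalfComm => halfcomm_rel end.

Definition comm_to_halfcomm : list step :=
  [SMulR 0; SMulL 0; SRelabel 2 3 [1;2;0]; SRelabel 1 3 [0;2;1]; STrans 3 4;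
   SRelabel 5 3 [1;0;2]; STrans 1 6].

(* For each non-identity permutation [p] of at most five letters: its kind, a derivation of
   the kind from [perm_rel p] and a derivation of [perm_rel p] from the kind. *)
Definition certificates : list (list nat * kind * list step * list step) := [
  ([1;0], Comm, [], []);
  ([0;2;1], Comm,
    [SMulL 0; SRelabel 1 4 [1;2;3;0]; SRelabel 2 3 [0;0;1;2]; SContr 3 0 0 0;
     SRelabel 4 2 [0;0;1]],
    [SMulL 0; SRelabel 1 3 [1;2;0]]);
  ([1;0;2], Comm,
    [SMulR 0; SRelabel 1 3 [0;1;2;2]; SContr 2 2 2 2; SRelabel 3 2 [0;1;0]],
    [SMulR 0]);
  ([1;2;0], Comm,
    [SMulR 0; SRelabel 1 3 [0;1;2;2]; SRelabel 0 3 [2;0;2]; SMulL 3;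
     SRelabel 4 3 [0;1;2;1]; STrans 2 5; SContr 6 2 2 2; SRelabel 7 2 [0;1;0]],
    [SMulR 0; SMulL 0; SRelabel 2 3 [1;2;0]; SRelabel 3 3 [1;0;2]; STrans 1 4]);
  ([2;0;1], Comm,
    [SStar 0; SRelabel 1 3 [2;1;0]; SMulR 2; SRelabel 3 3 [0;1;2;2]; SRelabel 2 3 [2;0;2];
     SMulL 5; SRelabel 6 3 [0;1;2;1]; STrans 4 7; SContr 8 2 2 2; SRelabel 9 2 [0;1;0]],
    [SMulL 0; SRelabel 1 3 [1;2;0]; SMulR 0; SRelabel 3 3 [0;2;1]; STrans 2 4]);
  ([2;1;0], HalfComm, [], []);
  ([0;1;3;2], Comm,
    [SRelabel 0 3 [0;0;1;2]; SContr 1 0 0 0; SRelabel 2 2 [0;0;1]],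
    [SMulL 0; SRelabel 1 3 [1;2;0]; SMulL 2; SRelabel 3 4 [1;2;3;0]]);
  ([0;2;1;3], Comm,
    [SMulR 0; SRelabel 1 4 [0;1;2;3;3]; SContr 2 3 3 3; SRelabel 3 3 [0;1;2;0]; SMulL 4;
     SRelabel 5 4 [1;2;3;0]; SRelabel 6 3 [0;0;1;2]; SContr 7 0 0 0;
     SRelabel 8 2 [0;0;1]],
    [SMulR 0; SMulL 1; SRelabel 2 4 [1;2;3;0]]);
  ([0;2;3;1], Comm,
    [SMulL 0; SRelabel 1 5 [1;2;3;4;0]; SRelabel 2 4 [0;0;1;2;3]; SContr 3 0 0 0;
     SRelabel 4 3 [0;0;1;2]; SMulR 5; SRelabel 6 3 [0;1;2;2]; SRelabel 5 3 [2;0;2];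
     SMulL 8; SRelabel 9 3 [0;1;2;1]; STrans 7 10; SContr 11 2 2 2;
     SRelabel 12 2 [0;1;0]],
    [SMulR 0; SMulL 1; SRelabel 2 4 [1;2;3;0]; SMulL 0; SRelabel 4 3 [1;2;0]; SMulL 5;
     SRelabel 6 4 [1;2;3;0]; SRelabel 7 4 [0;2;1;3]; STrans 3 8]);
  ([0;3;1;2], Comm,
    [SStar 0; SRelabel 1 4 [3;2;1;0]; SRelabel 2 4 [0;3;1;2]; STrans 0 3;
     SRelabel 4 3 [0;0;1;2]; SContr 5 0 0 1; SRelabel 6 2 [0;0;1]],
    [SMulL 0; SRelabel 1 3 [1;2;0]; SMulL 2; SRelabel 3 4 [1;2;3;0]; SMulR 0; SMulL 5;
     SRelabel 6 4 [1;2;3;0]; SRelabel 7 4 [0;1;3;2]; STrans 4 8]);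
  ([0;3;2;1], HalfComm,
    [SMulL 0; SRelabel 1 5 [1;2;3;4;0]; SRelabel 2 4 [0;0;1;2;3]; SContr 3 0 0 0;
     SRelabel 4 3 [0;0;1;2]],
    [SMulL 0; SRelabel 1 4 [1;2;3;0]]);
  ([1;0;2;3], Comm,
    [SRelabel 0 3 [0;1;2;2]; SContr 1 2 2 2; SRelabel 2 2 [0;1;0]],
    [SMulR 0; SMulR 1]);
  ([1;0;3;2], Comm,
    [SRelabel 0 3 [0;0;1;2]; SContr 1 0 0 0; SRelabel 2 2 [0;0;1]],
    [SMulR 0; SMulR 1; SMulL 0; SRelabel 3 3 [1;2;0]; SMulL 4; SRelabel 5 4 [1;2;3;0];
     SRelabel 6 4 [1;0;2;3]; STrans 2 7]);
  ([1;2;0;3], Comm,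
    [SMulR 0; SRelabel 1 4 [0;1;2;3;3]; SContr 2 3 3 3; SRelabel 3 3 [0;1;2;0]; SMulR 4;
     SRelabel 5 3 [0;1;2;2]; SRelabel 4 3 [2;0;2]; SMulL 7; SRelabel 8 3 [0;1;2;1];
     STrans 6 9; SContr 10 2 2 2; SRelabel 11 2 [0;1;0]],
    [SMulR 0; SMulR 1; SMulL 1; SRelabel 3 4 [1;2;3;0]; SRelabel 4 4 [1;0;2;3]; STrans 2 5]);
  ([1;2;3;0], Comm,
    [SRelabel 0 3 [0;1;1;2]; SContr 1 1 1 0; SRelabel 2 2 [0;0;1]],
    [SMulR 0; SMulR 1; SMulL 1; SRelabel 3 4 [1;2;3;0]; SMulL 0; SRelabel 5 3 [1;2;0];
     SMulL 6; SRelabel 7 4 [1;2;3;0]; SRelabel 8 4 [0;2;1;3]; STrans 4 9;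
     SRelabel 10 4 [1;0;2;3]; STrans 2 11]);
  ([1;3;0;2], Comm,
    [SRelabel 0 4 [1;3;0;2]; STrans 0 1; SRelabel 2 3 [0;1;2;2]; SContr 3 2 2 0;
     SRelabel 4 2 [0;1;0]],
    [SMulR 0; SMulR 1; SMulL 0; SRelabel 3 3 [1;2;0]; SMulL 4; SRelabel 5 4 [1;2;3;0];
     SMulL 1; SRelabel 7 4 [1;2;3;0]; SRelabel 8 4 [0;1;3;2]; STrans 6 9;
     SRelabel 10 4 [1;0;2;3]; STrans 2 11]);
  ([1;3;2;0], Comm,
    [SRelabel 0 3 [0;1;2;2]; SContr 1 2 2 1; SRelabel 2 2 [0;1;0]],
    [SMulR 0; SMulR 1; SMulL 1; SRelabel 3 4 [1;2;3;0]; SRelabel 4 4 [1;0;2;3]; STrans 2 5;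
     SMulL 0; SRelabel 7 3 [1;2;0]; SMulL 8; SRelabel 9 4 [1;2;3;0];
     SRelabel 4 4 [0;1;3;2]; STrans 10 11; SRelabel 12 4 [1;2;0;3]; STrans 6 13]);
  ([2;0;1;3], Comm,
    [SStar 0; SRelabel 1 4 [3;2;1;0]; SRelabel 2 4 [2;0;1;3]; STrans 0 3;
     SRelabel 4 3 [0;1;1;2]; SContr 5 1 1 0; SRelabel 6 2 [0;0;1]],
    [SMulR 0; SMulL 1; SRelabel 2 4 [1;2;3;0]; SMulR 1; SRelabel 4 4 [0;2;1;3]; STrans 3 5]);
  ([2;0;3;1], Comm,
    [SRelabel 0 4 [2;0;3;1]; STrans 0 1; SRelabel 2 3 [0;1;2;2]; SContr 3 2 2 0;
     SRelabel 4 2 [0;1;0]],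
    [SMulR 0; SMulL 1; SRelabel 2 4 [1;2;3;0]; SMulR 1; SMulL 0; SRelabel 5 3 [1;2;0];
     SMulL 6; SRelabel 7 4 [1;2;3;0]; SRelabel 8 4 [1;0;2;3]; STrans 4 9;
     SRelabel 10 4 [0;2;1;3]; STrans 3 11]);
  ([2;1;0;3], HalfComm,
    [SMulR 0; SRelabel 1 4 [0;1;2;3;3]; SContr 2 3 3 3; SRelabel 3 3 [0;1;2;0]],
    [SMulR 0]);
  ([2;1;3;0], Comm,
    [SRelabel 0 3 [0;1;1;2]; SContr 1 1 1 0; SRelabel 2 2 [0;0;1]],
    [SMulR 0; SMulR 1; SMulL 1; SRelabel 3 4 [1;2;3;0]; SRelabel 4 4 [1;0;2;3]; STrans 2 5;
     SMulL 0; SRelabel 7 3 [1;2;0]; SMulL 8; SRelabel 9 4 [1;2;3;0];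
     SRelabel 10 4 [1;0;2;3]; STrans 2 11; SRelabel 12 4 [1;2;0;3]; STrans 6 13]);
  ([2;3;0;1], HalfComm,
    [SMulR 0; SRelabel 1 4 [0;1;2;3;3]; SRelabel 0 4 [3;0;1;3]; SMulL 3;
     SRelabel 4 4 [0;1;2;3;2]; STrans 2 5; SContr 6 3 3 2; SRelabel 7 3 [0;1;2;0]],
    [SMulR 0; SMulL 0; SRelabel 2 4 [1;2;3;0]; SRelabel 3 4 [2;1;0;3]; STrans 1 4]);
  ([2;3;1;0], Comm,
    [SRelabel 0 3 [0;1;2;2]; SContr 1 2 2 0; SRelabel 2 2 [0;1;0]],
    [SMulR 0; SMulR 1; SMulL 1; SRelabel 3 4 [1;2;3;0]; SRelabel 2 4 [0;2;1;3]; STrans 4 5;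
     SMulL 0; SRelabel 7 3 [1;2;0]; SMulL 8; SRelabel 9 4 [1;2;3;0];
     SRelabel 4 4 [0;1;3;2]; STrans 10 11; SRelabel 12 4 [2;0;1;3]; STrans 6 13;
     SRelabel 14 4 [1;0;2;3]; STrans 2 15]);
  ([3;0;1;2], Comm,
    [SRelabel 0 3 [0;0;1;2]; SContr 1 0 0 1; SRelabel 2 2 [0;0;1]],
    [SMulL 0; SRelabel 1 3 [1;2;0]; SMulL 2; SRelabel 3 4 [1;2;3;0]; SMulR 0; SMulL 5;
     SRelabel 6 4 [1;2;3;0]; SMulR 5; SRelabel 8 4 [0;2;1;3]; STrans 7 9;
     SRelabel 10 4 [0;1;3;2]; STrans 4 11]);
  ([3;0;2;1], Comm,
    [SRelabel 0 3 [0;1;1;2]; SContr 1 1 1 2; SRelabel 2 2 [0;0;1]],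
    [SMulR 0; SMulL 1; SRelabel 2 4 [1;2;3;0]; SMulL 0; SRelabel 4 3 [1;2;0]; SMulL 5;
     SRelabel 6 4 [1;2;3;0]; SRelabel 7 4 [0;2;1;3]; STrans 3 8; SMulR 1;
     SRelabel 10 4 [0;2;1;3]; STrans 3 11; SRelabel 12 4 [0;2;3;1]; STrans 9 13]);
  ([3;1;0;2], Comm,
    [SRelabel 0 3 [0;0;1;2]; SContr 1 0 0 1; SRelabel 2 2 [0;0;1]],
    [SMulR 0; SMulR 1; SMulL 0; SRelabel 3 3 [1;2;0]; SMulL 4; SRelabel 5 4 [1;2;3;0];
     SRelabel 6 4 [1;0;2;3]; STrans 2 7; SMulL 1; SRelabel 9 4 [1;2;3;0];
     SRelabel 2 4 [0;2;1;3]; STrans 10 11; SRelabel 12 4 [1;0;3;2]; STrans 8 13]);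
  ([3;1;2;0], Comm,
    [SRelabel 0 3 [0;1;1;2]; SContr 1 1 1 1; SRelabel 2 2 [0;0;1]],
    [SMulR 0; SMulR 1; SMulL 1; SRelabel 3 4 [1;2;3;0]; SMulL 0; SRelabel 5 3 [1;2;0];
     SMulL 6; SRelabel 7 4 [1;2;3;0]; SRelabel 8 4 [0;2;1;3]; STrans 4 9;
     SRelabel 2 4 [0;2;1;3]; STrans 4 11; SRelabel 12 4 [0;2;3;1]; STrans 10 13;
     SRelabel 14 4 [1;0;2;3]; STrans 2 15]);
  ([3;2;0;1], Comm,
    [SRelabel 0 3 [0;0;1;2]; SContr 1 0 0 2; SRelabel 2 2 [0;0;1]],
    [SMulR 0; SMulL 1; SRelabel 2 4 [1;2;3;0]; SMulR 1; SMulL 0; SRelabel 5 3 [1;2;0];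
     SMulL 6; SRelabel 7 4 [1;2;3;0]; SRelabel 8 4 [1;0;2;3]; STrans 4 9;
     SRelabel 4 4 [0;2;1;3]; STrans 3 11; SRelabel 12 4 [1;0;3;2]; STrans 10 13;
     SRelabel 14 4 [0;2;1;3]; STrans 3 15]);
  ([3;2;1;0], Comm,
    [SRelabel 0 3 [0;1;2;2]; SContr 1 2 2 0; SRelabel 2 2 [0;1;0]],
    [SMulR 0; SMulR 1; SMulL 1; SRelabel 3 4 [1;2;3;0]; SRelabel 4 4 [1;0;2;3]; STrans 2 5;
     SMulL 0; SRelabel 7 3 [1;2;0]; SMulL 8; SRelabel 9 4 [1;2;3;0];
     SRelabel 10 4 [1;0;2;3]; STrans 2 11; SRelabel 2 4 [0;2;1;3]; STrans 4 13;
     SRelabel 14 4 [1;0;3;2]; STrans 12 15; SRelabel 16 4 [1;2;0;3]; STrans 6 17]);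
  ([0;1;2;4;3], Comm,
    [SRelabel 0 4 [0;0;1;2;3]; SContr 1 0 0 0; SRelabel 2 3 [0;0;1;2]; SMulL 3;
     SRelabel 4 4 [1;2;3;0]; SRelabel 5 3 [0;0;1;2]; SContr 6 0 0 0;
     SRelabel 7 2 [0;0;1]],
    [SMulL 0; SRelabel 1 3 [1;2;0]; SMulL 2; SRelabel 3 4 [1;2;3;0]; SMulL 4;
     SRelabel 5 5 [1;2;3;4;0]]);
  ([0;1;3;2;4], Comm,
    [SRelabel 0 4 [0;0;1;2;3]; SContr 1 0 0 0; SRelabel 2 3 [0;0;1;2]; SMulR 3;
     SRelabel 4 3 [0;1;2;2]; SContr 5 2 2 2; SRelabel 6 2 [0;1;0]],
    [SMulR 0; SMulL 1; SRelabel 2 4 [1;2;3;0]; SMulL 3; SRelabel 4 5 [1;2;3;4;0]]);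
  ([0;1;3;4;2], Comm,
    [SRelabel 0 4 [0;0;1;2;3]; SContr 1 0 0 0; SRelabel 2 3 [0;0;1;2]; SMulR 3;
     SRelabel 4 3 [0;1;2;2]; SRelabel 3 3 [2;0;2]; SMulL 6; SRelabel 7 3 [0;1;2;1];
     STrans 5 8; SContr 9 2 2 2; SRelabel 10 2 [0;1;0]],
    [SMulR 0; SMulL 1; SRelabel 2 4 [1;2;3;0]; SMulL 3; SRelabel 4 5 [1;2;3;4;0]; SMulL 0;
     SRelabel 6 3 [1;2;0]; SMulL 7; SRelabel 8 4 [1;2;3;0]; SMulL 9;
     SRelabel 10 5 [1;2;3;4;0]; SRelabel 11 5 [0;1;3;2;4]; STrans 5 12]);
  ([0;1;4;2;3], Comm,
    [SStar 0; SRelabel 1 5 [4;3;2;1;0]; SRelabel 2 4 [0;1;2;3;3]; SContr 3 3 3 3;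
     SRelabel 4 3 [0;1;2;0]; SMulR 5; SRelabel 6 3 [0;1;2;2]; SRelabel 5 3 [2;0;2];
     SMulL 8; SRelabel 9 3 [0;1;2;1]; STrans 7 10; SContr 11 2 2 2;
     SRelabel 12 2 [0;1;0]],
    [SMulL 0; SRelabel 1 3 [1;2;0]; SMulL 2; SRelabel 3 4 [1;2;3;0]; SMulL 4;
     SRelabel 5 5 [1;2;3;4;0]; SMulR 0; SMulL 7; SRelabel 8 4 [1;2;3;0]; SMulL 9;
     SRelabel 10 5 [1;2;3;4;0]; SRelabel 11 5 [0;1;2;4;3]; STrans 6 12]);
  ([0;1;4;3;2], HalfComm,
    [SRelabel 0 4 [0;0;1;2;3]; SContr 1 0 0 0; SRelabel 2 3 [0;0;1;2]],
    [SMulL 0; SRelabel 1 4 [1;2;3;0]; SMulL 2; SRelabel 3 5 [1;2;3;4;0]]);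
  ([0;2;1;3;4], Comm,
    [SRelabel 0 4 [0;1;2;3;3]; SContr 1 3 3 3; SRelabel 2 3 [0;1;2;0]; SMulL 3;
     SRelabel 4 4 [1;2;3;0]; SRelabel 5 3 [0;0;1;2]; SContr 6 0 0 0;
     SRelabel 7 2 [0;0;1]],
    [SMulR 0; SMulR 1; SMulL 2; SRelabel 3 5 [1;2;3;4;0]]);
  ([0;2;1;4;3], Comm,
    [SRelabel 0 4 [0;1;1;2;3]; SContr 1 1 1 1; SRelabel 2 3 [0;0;1;2]; SMulL 3;
     SRelabel 4 4 [1;2;3;0]; SRelabel 5 3 [0;0;1;2]; SContr 6 0 0 0;
     SRelabel 7 2 [0;0;1]],
    [SMulR 0; SMulR 1; SMulL 2; SRelabel 3 5 [1;2;3;4;0]; SMulL 0; SRelabel 5 3 [1;2;0];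
     SMulL 6; SRelabel 7 4 [1;2;3;0]; SMulL 8; SRelabel 9 5 [1;2;3;4;0];
     SRelabel 10 5 [0;2;1;3;4]; STrans 4 11]);
  ([0;2;3;1;4], Comm,
    [SMulL 0; SRelabel 1 6 [1;2;3;4;5;0]; SRelabel 2 5 [0;0;1;2;3;4]; SContr 3 0 0 0;
     SRelabel 4 4 [0;0;1;2;3]; SMulR 0; SRelabel 6 5 [0;1;2;3;4;4]; SContr 7 4 4 4;
     SRelabel 8 4 [0;1;2;3;0]; SRelabel 9 4 [1;2;0;3]; STrans 5 10;
     SRelabel 11 3 [0;0;1;2]; SContr 12 0 0 0; SRelabel 13 2 [0;0;1]],
    [SMulR 0; SMulR 1; SMulL 2; SRelabel 3 5 [1;2;3;4;0]; SMulL 1; SRelabel 5 4 [1;2;3;0];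
     SMulL 6; SRelabel 7 5 [1;2;3;4;0]; SRelabel 8 5 [0;2;1;3;4]; STrans 4 9]);
  ([0;2;3;4;1], Comm,
    [SRelabel 0 4 [0;1;2;2;3]; SContr 1 2 2 1; SRelabel 2 3 [0;1;0;2]; SMulL 3;
     SRelabel 4 4 [1;2;3;0]; SRelabel 5 3 [0;0;1;2]; SContr 6 0 0 0;
     SRelabel 7 2 [0;0;1]],
    [SMulR 0; SMulR 1; SMulL 2; SRelabel 3 5 [1;2;3;4;0]; SMulL 1; SRelabel 5 4 [1;2;3;0];
     SMulL 6; SRelabel 7 5 [1;2;3;4;0]; SMulL 0; SRelabel 9 3 [1;2;0]; SMulL 10;
     SRelabel 11 4 [1;2;3;0]; SMulL 12; SRelabel 13 5 [1;2;3;4;0];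
     SRelabel 14 5 [0;1;3;2;4]; STrans 8 15; SRelabel 16 5 [0;2;1;3;4]; STrans 4 17]);
  ([0;2;4;1;3], Comm,
    [SMulL 0; SRelabel 1 6 [1;2;3;4;5;0]; SRelabel 2 5 [0;0;1;2;3;4]; SContr 3 0 0 0;
     SRelabel 4 4 [0;0;1;2;3]; SRelabel 5 4 [1;3;0;2]; STrans 5 6;
     SRelabel 7 3 [0;1;2;2]; SContr 8 2 2 0; SRelabel 9 2 [0;1;0]],
    [SMulR 0; SMulR 1; SMulL 2; SRelabel 3 5 [1;2;3;4;0]; SMulL 0; SRelabel 5 3 [1;2;0];
     SMulL 6; SRelabel 7 4 [1;2;3;0]; SMulL 8; SRelabel 9 5 [1;2;3;4;0]; SMulL 1;
     SRelabel 11 4 [1;2;3;0]; SMulL 12; SRelabel 13 5 [1;2;3;4;0];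
     SRelabel 14 5 [0;1;2;4;3]; STrans 10 15; SRelabel 16 5 [0;2;1;3;4]; STrans 4 17]);
  ([0;2;4;3;1], Comm,
    [SRelabel 0 4 [0;1;2;3;3]; SContr 1 3 3 2; SRelabel 2 3 [0;1;2;0]; SMulL 3;
     SRelabel 4 4 [1;2;3;0]; SRelabel 5 3 [0;0;1;2]; SContr 6 0 0 0;
     SRelabel 7 2 [0;0;1]],
    [SMulR 0; SMulR 1; SMulL 2; SRelabel 3 5 [1;2;3;4;0]; SMulL 1; SRelabel 5 4 [1;2;3;0];
     SMulL 6; SRelabel 7 5 [1;2;3;4;0]; SRelabel 8 5 [0;2;1;3;4]; STrans 4 9; SMulL 0;
     SRelabel 11 3 [1;2;0]; SMulL 12; SRelabel 13 4 [1;2;3;0]; SMulL 14;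
     SRelabel 15 5 [1;2;3;4;0]; SRelabel 8 5 [0;1;2;4;3]; STrans 16 17;
     SRelabel 18 5 [0;2;3;1;4]; STrans 10 19]);
  ([0;3;1;2;4], Comm,
    [SMulR 0; SRelabel 1 5 [0;1;2;3;4;4]; SContr 2 4 4 4; SRelabel 3 4 [0;1;2;3;0];
     SMulL 0; SRelabel 5 6 [1;2;3;4;5;0]; SRelabel 6 5 [0;0;1;2;3;4]; SContr 7 0 0 0;
     SRelabel 8 4 [0;0;1;2;3]; SRelabel 9 4 [0;3;1;2]; STrans 4 10;
     SRelabel 11 3 [0;0;1;2]; SContr 12 0 0 0; SRelabel 13 2 [0;0;1]],
    [SMulR 0; SMulL 1; SRelabel 2 4 [1;2;3;0]; SMulL 3; SRelabel 4 5 [1;2;3;4;0]; SMulR 1;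
     SMulL 6; SRelabel 7 5 [1;2;3;4;0]; SRelabel 8 5 [0;1;3;2;4]; STrans 5 9]);
  ([0;3;1;4;2], Comm,
    [SMulL 0; SRelabel 1 6 [1;2;3;4;5;0]; SRelabel 2 5 [0;0;1;2;3;4]; SContr 3 0 0 0;
     SRelabel 4 4 [0;0;1;2;3]; SRelabel 5 4 [2;0;3;1]; STrans 5 6;
     SRelabel 7 3 [0;1;2;2]; SContr 8 2 2 0; SRelabel 9 2 [0;1;0]],
    [SMulR 0; SMulL 1; SRelabel 2 4 [1;2;3;0]; SMulL 3; SRelabel 4 5 [1;2;3;4;0]; SMulR 1;
     SMulL 6; SRelabel 7 5 [1;2;3;4;0]; SMulL 0; SRelabel 9 3 [1;2;0]; SMulL 10;
     SRelabel 11 4 [1;2;3;0]; SMulL 12; SRelabel 13 5 [1;2;3;4;0];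
     SRelabel 14 5 [0;2;1;3;4]; STrans 8 15; SRelabel 16 5 [0;1;3;2;4]; STrans 5 17]);
  ([0;3;2;1;4], HalfComm,
    [SMulR 0; SRelabel 1 5 [0;1;2;3;4;4]; SContr 2 4 4 4; SRelabel 3 4 [0;1;2;3;0];
     SMulL 4; SRelabel 5 5 [1;2;3;4;0]; SRelabel 6 4 [0;0;1;2;3]; SContr 7 0 0 0;
     SRelabel 8 3 [0;0;1;2]],
    [SMulR 0; SMulL 1; SRelabel 2 5 [1;2;3;4;0]]);
  ([0;3;2;4;1], Comm,
    [SRelabel 0 4 [0;1;2;2;3]; SContr 1 2 2 1; SRelabel 2 3 [0;1;0;2]; SMulL 3;
     SRelabel 4 4 [1;2;3;0]; SRelabel 5 3 [0;0;1;2]; SContr 6 0 0 0;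
     SRelabel 7 2 [0;0;1]],
    [SMulR 0; SMulR 1; SMulL 2; SRelabel 3 5 [1;2;3;4;0]; SMulL 1; SRelabel 5 4 [1;2;3;0];
     SMulL 6; SRelabel 7 5 [1;2;3;4;0]; SRelabel 8 5 [0;2;1;3;4]; STrans 4 9; SMulL 0;
     SRelabel 11 3 [1;2;0]; SMulL 12; SRelabel 13 4 [1;2;3;0]; SMulL 14;
     SRelabel 15 5 [1;2;3;4;0]; SRelabel 16 5 [0;2;1;3;4]; STrans 4 17;
     SRelabel 18 5 [0;2;3;1;4]; STrans 10 19]);
  ([0;3;4;1;2], HalfComm,
    [SMulL 0; SRelabel 1 6 [1;2;3;4;5;0]; SRelabel 2 5 [0;0;1;2;3;4]; SContr 3 0 0 0;
     SRelabel 4 4 [0;0;1;2;3]; SMulR 5; SRelabel 6 4 [0;1;2;3;3];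
     SRelabel 5 4 [3;0;1;3]; SMulL 8; SRelabel 9 4 [0;1;2;3;2]; STrans 7 10;
     SContr 11 3 3 2; SRelabel 12 3 [0;1;2;0]],
    [SMulR 0; SMulL 1; SRelabel 2 5 [1;2;3;4;0]; SMulL 0; SRelabel 4 4 [1;2;3;0]; SMulL 5;
     SRelabel 6 5 [1;2;3;4;0]; SRelabel 7 5 [0;3;2;1;4]; STrans 3 8]);
  ([0;3;4;2;1], Comm,
    [SRelabel 0 4 [0;1;2;3;3]; SContr 1 3 3 1; SRelabel 2 3 [0;1;2;0]; SMulL 3;
     SRelabel 4 4 [1;2;3;0]; SRelabel 5 3 [0;0;1;2]; SContr 6 0 0 0;
     SRelabel 7 2 [0;0;1]],
    [SMulR 0; SMulR 1; SMulL 2; SRelabel 3 5 [1;2;3;4;0]; SMulL 1; SRelabel 5 4 [1;2;3;0];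
     SMulL 6; SRelabel 7 5 [1;2;3;4;0]; SRelabel 4 5 [0;1;3;2;4]; STrans 8 9; SMulL 0;
     SRelabel 11 3 [1;2;0]; SMulL 12; SRelabel 13 4 [1;2;3;0]; SMulL 14;
     SRelabel 15 5 [1;2;3;4;0]; SRelabel 8 5 [0;1;2;4;3]; STrans 16 17;
     SRelabel 18 5 [0;3;1;2;4]; STrans 10 19; SRelabel 20 5 [0;2;1;3;4]; STrans 4 21]);
  ([0;4;1;2;3], Comm,
    [SRelabel 0 4 [0;1;1;2;3]; SContr 1 1 1 2; SRelabel 2 3 [0;0;1;2]; SMulL 3;
     SRelabel 4 4 [1;2;3;0]; SRelabel 5 3 [0;0;1;2]; SContr 6 0 0 0;
     SRelabel 7 2 [0;0;1]],
    [SMulL 0; SRelabel 1 3 [1;2;0]; SMulL 2; SRelabel 3 4 [1;2;3;0]; SMulL 4;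
     SRelabel 5 5 [1;2;3;4;0]; SMulR 0; SMulL 7; SRelabel 8 4 [1;2;3;0]; SMulL 9;
     SRelabel 10 5 [1;2;3;4;0]; SMulR 7; SMulL 12; SRelabel 13 5 [1;2;3;4;0];
     SRelabel 14 5 [0;1;3;2;4]; STrans 11 15; SRelabel 16 5 [0;1;2;4;3]; STrans 6 17]);
  ([0;4;1;3;2], Comm,
    [SRelabel 0 4 [0;1;2;2;3]; SContr 1 2 2 3; SRelabel 2 3 [0;1;0;2]; SMulL 3;
     SRelabel 4 4 [1;2;3;0]; SRelabel 5 3 [0;0;1;2]; SContr 6 0 0 0;
     SRelabel 7 2 [0;0;1]],
    [SMulR 0; SMulL 1; SRelabel 2 4 [1;2;3;0]; SMulL 3; SRelabel 4 5 [1;2;3;4;0]; SMulL 0;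
     SRelabel 6 3 [1;2;0]; SMulL 7; SRelabel 8 4 [1;2;3;0]; SMulL 9;
     SRelabel 10 5 [1;2;3;4;0]; SRelabel 11 5 [0;1;3;2;4]; STrans 5 12; SMulR 1;
     SMulL 14; SRelabel 15 5 [1;2;3;4;0]; SRelabel 16 5 [0;1;3;2;4]; STrans 5 17;
     SRelabel 18 5 [0;1;3;4;2]; STrans 13 19]);
  ([0;4;2;1;3], Comm,
    [SRelabel 0 4 [0;1;1;2;3]; SContr 1 1 1 2; SRelabel 2 3 [0;0;1;2]; SMulL 3;
     SRelabel 4 4 [1;2;3;0]; SRelabel 5 3 [0;0;1;2]; SContr 6 0 0 0;
     SRelabel 7 2 [0;0;1]],
    [SMulR 0; SMulR 1; SMulL 2; SRelabel 3 5 [1;2;3;4;0]; SMulL 0; SRelabel 5 3 [1;2;0];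
     SMulL 6; SRelabel 7 4 [1;2;3;0]; SMulL 8; SRelabel 9 5 [1;2;3;4;0];
     SRelabel 10 5 [0;2;1;3;4]; STrans 4 11; SMulL 1; SRelabel 13 4 [1;2;3;0];
     SMulL 14; SRelabel 15 5 [1;2;3;4;0]; SRelabel 4 5 [0;1;3;2;4]; STrans 16 17;
     SRelabel 18 5 [0;2;1;4;3]; STrans 12 19]);
  ([0;4;2;3;1], Comm,
    [SRelabel 0 4 [0;1;2;2;3]; SContr 1 2 2 2; SRelabel 2 3 [0;1;0;2]; SMulL 3;
     SRelabel 4 4 [1;2;3;0]; SRelabel 5 3 [0;0;1;2]; SContr 6 0 0 0;
     SRelabel 7 2 [0;0;1]],
    [SMulR 0; SMulR 1; SMulL 2; SRelabel 3 5 [1;2;3;4;0]; SMulL 1; SRelabel 5 4 [1;2;3;0];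
     SMulL 6; SRelabel 7 5 [1;2;3;4;0]; SMulL 0; SRelabel 9 3 [1;2;0]; SMulL 10;
     SRelabel 11 4 [1;2;3;0]; SMulL 12; SRelabel 13 5 [1;2;3;4;0];
     SRelabel 14 5 [0;1;3;2;4]; STrans 8 15; SRelabel 4 5 [0;1;3;2;4]; STrans 8 17;
     SRelabel 18 5 [0;1;3;4;2]; STrans 16 19; SRelabel 20 5 [0;2;1;3;4]; STrans 4 21]);
  ([0;4;3;1;2], Comm,
    [SRelabel 0 4 [0;1;1;2;3]; SContr 1 1 1 3; SRelabel 2 3 [0;0;1;2]; SMulL 3;
     SRelabel 4 4 [1;2;3;0]; SRelabel 5 3 [0;0;1;2]; SContr 6 0 0 0;
     SRelabel 7 2 [0;0;1]],
    [SMulR 0; SMulL 1; SRelabel 2 4 [1;2;3;0]; SMulL 3; SRelabel 4 5 [1;2;3;4;0]; SMulR 1;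
     SMulL 6; SRelabel 7 5 [1;2;3;4;0]; SMulL 0; SRelabel 9 3 [1;2;0]; SMulL 10;
     SRelabel 11 4 [1;2;3;0]; SMulL 12; SRelabel 13 5 [1;2;3;4;0];
     SRelabel 14 5 [0;2;1;3;4]; STrans 8 15; SRelabel 8 5 [0;1;3;2;4]; STrans 5 17;
     SRelabel 18 5 [0;2;1;4;3]; STrans 16 19; SRelabel 20 5 [0;1;3;2;4]; STrans 5 21]);
  ([0;4;3;2;1], Comm,
    [SRelabel 0 4 [0;1;2;3;3]; SContr 1 3 3 1; SRelabel 2 3 [0;1;2;0]; SMulL 3;
     SRelabel 4 4 [1;2;3;0]; SRelabel 5 3 [0;0;1;2]; SContr 6 0 0 0;
     SRelabel 7 2 [0;0;1]],
    [SMulR 0; SMulR 1; SMulL 2; SRelabel 3 5 [1;2;3;4;0]; SMulL 1; SRelabel 5 4 [1;2;3;0];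
     SMulL 6; SRelabel 7 5 [1;2;3;4;0]; SRelabel 8 5 [0;2;1;3;4]; STrans 4 9; SMulL 0;
     SRelabel 11 3 [1;2;0]; SMulL 12; SRelabel 13 4 [1;2;3;0]; SMulL 14;
     SRelabel 15 5 [1;2;3;4;0]; SRelabel 16 5 [0;2;1;3;4]; STrans 4 17;
     SRelabel 4 5 [0;1;3;2;4]; STrans 8 19; SRelabel 20 5 [0;2;1;4;3]; STrans 18 21;
     SRelabel 22 5 [0;2;3;1;4]; STrans 10 23]);
  ([1;0;2;3;4], Comm,
    [SRelabel 0 4 [0;1;2;2;3]; SContr 1 2 2 2; SRelabel 2 3 [0;1;0;2]; SMulR 3;
     SRelabel 4 3 [0;1;2;2]; SContr 5 2 2 2; SRelabel 6 2 [0;1;0]],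
    [SMulR 0; SMulR 1; SMulR 2]);
  ([1;0;2;4;3], Comm,
    [SRelabel 0 4 [0;0;1;2;3]; SContr 1 0 0 0; SRelabel 2 3 [0;0;1;2]; SMulL 3;
     SRelabel 4 4 [1;2;3;0]; SRelabel 5 3 [0;0;1;2]; SContr 6 0 0 0;
     SRelabel 7 2 [0;0;1]],
    [SMulR 0; SMulR 1; SMulR 2; SMulL 0; SRelabel 4 3 [1;2;0]; SMulL 5;
     SRelabel 6 4 [1;2;3;0]; SMulL 7; SRelabel 8 5 [1;2;3;4;0];
     SRelabel 9 5 [1;0;2;3;4]; STrans 3 10]);
  ([1;0;3;2;4], Comm,
    [SRelabel 0 4 [0;0;1;2;3]; SContr 1 0 0 0; SRelabel 2 3 [0;0;1;2]; SMulR 3;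
     SRelabel 4 3 [0;1;2;2]; SContr 5 2 2 2; SRelabel 6 2 [0;1;0]],
    [SMulR 0; SMulR 1; SMulR 2; SMulL 1; SRelabel 4 4 [1;2;3;0]; SMulL 5;
     SRelabel 6 5 [1;2;3;4;0]; SRelabel 7 5 [1;0;2;3;4]; STrans 3 8]);
  ([1;0;3;4;2], Comm,
    [SRelabel 0 4 [0;1;2;3;3]; SContr 1 3 3 2; SRelabel 2 3 [0;1;2;0]; SMulR 3;
     SRelabel 4 3 [0;1;2;2]; SContr 5 2 2 2; SRelabel 6 2 [0;1;0]],
    [SMulR 0; SMulR 1; SMulR 2; SMulL 1; SRelabel 4 4 [1;2;3;0]; SMulL 5;
     SRelabel 6 5 [1;2;3;4;0]; SMulL 0; SRelabel 8 3 [1;2;0]; SMulL 9;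
     SRelabel 10 4 [1;2;3;0]; SMulL 11; SRelabel 12 5 [1;2;3;4;0];
     SRelabel 13 5 [0;1;3;2;4]; STrans 7 14; SRelabel 15 5 [1;0;2;3;4]; STrans 3 16]);
  ([1;0;4;2;3], Comm,
    [SRelabel 0 4 [0;1;2;2;3]; SContr 1 2 2 3; SRelabel 2 3 [0;1;0;2]; SMulR 3;
     SRelabel 4 3 [0;1;2;2]; SContr 5 2 2 2; SRelabel 6 2 [0;1;0]],
    [SMulR 0; SMulR 1; SMulR 2; SMulL 0; SRelabel 4 3 [1;2;0]; SMulL 5;
     SRelabel 6 4 [1;2;3;0]; SMulL 7; SRelabel 8 5 [1;2;3;4;0]; SMulL 1;
     SRelabel 10 4 [1;2;3;0]; SMulL 11; SRelabel 12 5 [1;2;3;4;0];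
     SRelabel 13 5 [0;1;2;4;3]; STrans 9 14; SRelabel 15 5 [1;0;2;3;4]; STrans 3 16]);
  ([1;0;4;3;2], Comm,
    [SRelabel 0 4 [0;1;2;3;3]; SContr 1 3 3 2; SRelabel 2 3 [0;1;2;0]; SMulR 3;
     SRelabel 4 3 [0;1;2;2]; SContr 5 2 2 2; SRelabel 6 2 [0;1;0]],
    [SMulR 0; SMulR 1; SMulR 2; SMulL 1; SRelabel 4 4 [1;2;3;0]; SMulL 5;
     SRelabel 6 5 [1;2;3;4;0]; SRelabel 7 5 [1;0;2;3;4]; STrans 3 8; SMulL 0;
     SRelabel 10 3 [1;2;0]; SMulL 11; SRelabel 12 4 [1;2;3;0]; SMulL 13;
     SRelabel 14 5 [1;2;3;4;0]; SRelabel 7 5 [0;1;2;4;3]; STrans 15 16;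
     SRelabel 17 5 [1;0;3;2;4]; STrans 9 18]);
  ([1;2;0;3;4], Comm,
    [SRelabel 0 4 [0;1;2;3;3]; SContr 1 3 3 3; SRelabel 2 3 [0;1;2;0]; SMulR 3;
     SRelabel 4 3 [0;1;2;2]; SRelabel 3 3 [2;0;2]; SMulL 6; SRelabel 7 3 [0;1;2;1];
     STrans 5 8; SContr 9 2 2 2; SRelabel 10 2 [0;1;0]],
    [SMulR 0; SMulR 1; SMulR 2; SMulL 2; SRelabel 4 5 [1;2;3;4;0];
     SRelabel 5 5 [1;0;2;3;4]; STrans 3 6]);
  ([1;2;0;4;3], Comm,
    [SRelabel 0 4 [0;1;1;2;3]; SContr 1 1 1 0; SRelabel 2 3 [0;0;1;2]; SMulL 3;
     SRelabel 4 4 [1;2;3;0]; SRelabel 5 3 [0;0;1;2]; SContr 6 0 0 0;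
     SRelabel 7 2 [0;0;1]],
    [SMulR 0; SMulR 1; SMulR 2; SMulL 2; SRelabel 4 5 [1;2;3;4;0]; SMulL 0;
     SRelabel 6 3 [1;2;0]; SMulL 7; SRelabel 8 4 [1;2;3;0]; SMulL 9;
     SRelabel 10 5 [1;2;3;4;0]; SRelabel 11 5 [0;2;1;3;4]; STrans 5 12;
     SRelabel 13 5 [1;0;2;3;4]; STrans 3 14]);
  ([1;2;3;0;4], Comm,
    [SRelabel 0 4 [0;1;1;2;3]; SContr 1 1 1 0; SRelabel 2 3 [0;0;1;2]; SMulR 3;
     SRelabel 4 3 [0;1;2;2]; SContr 5 2 2 2; SRelabel 6 2 [0;1;0]],
    [SMulR 0; SMulR 1; SMulR 2; SMulL 2; SRelabel 4 5 [1;2;3;4;0]; SMulL 1;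
     SRelabel 6 4 [1;2;3;0]; SMulL 7; SRelabel 8 5 [1;2;3;4;0];
     SRelabel 9 5 [0;2;1;3;4]; STrans 5 10; SRelabel 11 5 [1;0;2;3;4]; STrans 3 12]);
  ([1;2;3;4;0], Comm,
    [SRelabel 0 4 [0;1;1;2;3]; SContr 1 1 1 0; SRelabel 2 3 [0;0;1;2]; SMulR 3;
     SRelabel 4 3 [0;1;2;2]; SRelabel 3 3 [2;0;2]; SMulL 6; SRelabel 7 3 [0;1;2;1];
     STrans 5 8; SContr 9 2 2 2; SRelabel 10 2 [0;1;0]],
    [SMulR 0; SMulR 1; SMulR 2; SMulL 2; SRelabel 4 5 [1;2;3;4;0];
     SRelabel 5 5 [1;0;2;3;4]; STrans 3 6; SMulL 1; SRelabel 8 4 [1;2;3;0]; SMulL 9;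
     SRelabel 10 5 [1;2;3;4;0]; SMulL 0; SRelabel 12 3 [1;2;0]; SMulL 13;
     SRelabel 14 4 [1;2;3;0]; SMulL 15; SRelabel 16 5 [1;2;3;4;0];
     SRelabel 17 5 [0;1;3;2;4]; STrans 11 18; SRelabel 19 5 [1;2;0;3;4]; STrans 7 20]);
  ([1;2;4;0;3], Comm,
    [SRelabel 0 5 [1;2;4;0;3]; STrans 0 1; SRelabel 2 4 [0;0;1;2;3]; SContr 3 0 0 3;
     SRelabel 4 3 [0;0;1;2]; SMulL 5; SRelabel 6 4 [1;2;3;0]; SRelabel 7 3 [0;0;1;2];
     SContr 8 0 0 0; SRelabel 9 2 [0;0;1]],
    [SMulR 0; SMulR 1; SMulR 2; SMulL 2; SRelabel 4 5 [1;2;3;4;0];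
     SRelabel 5 5 [1;0;2;3;4]; STrans 3 6; SMulL 0; SRelabel 8 3 [1;2;0]; SMulL 9;
     SRelabel 10 4 [1;2;3;0]; SMulL 11; SRelabel 12 5 [1;2;3;4;0]; SMulL 1;
     SRelabel 14 4 [1;2;3;0]; SMulL 15; SRelabel 16 5 [1;2;3;4;0];
     SRelabel 17 5 [0;1;2;4;3]; STrans 13 18; SRelabel 19 5 [1;2;0;3;4]; STrans 7 20]);
  ([1;2;4;3;0], Comm,
    [SRelabel 0 4 [0;1;2;3;3]; SContr 1 3 3 2; SRelabel 2 3 [0;1;2;0]; SMulR 3;
     SRelabel 4 3 [0;1;2;2]; SRelabel 3 3 [2;0;2]; SMulL 6; SRelabel 7 3 [0;1;2;1];
     STrans 5 8; SContr 9 2 2 2; SRelabel 10 2 [0;1;0]],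
    [SMulR 0; SMulR 1; SMulR 2; SMulL 2; SRelabel 4 5 [1;2;3;4;0]; SMulL 1;
     SRelabel 6 4 [1;2;3;0]; SMulL 7; SRelabel 8 5 [1;2;3;4;0];
     SRelabel 9 5 [0;2;1;3;4]; STrans 5 10; SMulL 0; SRelabel 12 3 [1;2;0]; SMulL 13;
     SRelabel 14 4 [1;2;3;0]; SMulL 15; SRelabel 16 5 [1;2;3;4;0];
     SRelabel 9 5 [0;1;2;4;3]; STrans 17 18; SRelabel 19 5 [0;2;3;1;4]; STrans 11 20;
     SRelabel 21 5 [1;0;2;3;4]; STrans 3 22]);
  ([1;3;0;2;4], Comm,
    [SMulR 0; SRelabel 1 5 [0;1;2;3;4;4]; SContr 2 4 4 4; SRelabel 3 4 [0;1;2;3;0];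
     SRelabel 4 4 [1;3;0;2]; STrans 4 5; SRelabel 6 3 [0;1;2;2]; SContr 7 2 2 0;
     SRelabel 8 2 [0;1;0]],
    [SMulR 0; SMulR 1; SMulR 2; SMulL 1; SRelabel 4 4 [1;2;3;0]; SMulL 5;
     SRelabel 6 5 [1;2;3;4;0]; SMulL 2; SRelabel 8 5 [1;2;3;4;0];
     SRelabel 9 5 [0;1;3;2;4]; STrans 7 10; SRelabel 11 5 [1;0;2;3;4]; STrans 3 12]);
  ([1;3;0;4;2], Comm,
    [SRelabel 0 5 [1;3;0;4;2]; STrans 0 1; SRelabel 2 4 [0;1;2;3;3]; SContr 3 3 3 0;
     SRelabel 4 3 [0;1;2;0]; SMulR 5; SRelabel 6 3 [0;1;2;2]; SRelabel 5 3 [2;0;2];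
     SMulL 8; SRelabel 9 3 [0;1;2;1]; STrans 7 10; SContr 11 2 2 2;
     SRelabel 12 2 [0;1;0]],
    [SMulR 0; SMulR 1; SMulR 2; SMulL 1; SRelabel 4 4 [1;2;3;0]; SMulL 5;
     SRelabel 6 5 [1;2;3;4;0]; SRelabel 7 5 [1;0;2;3;4]; STrans 3 8; SMulL 2;
     SRelabel 10 5 [1;2;3;4;0]; SMulL 0; SRelabel 12 3 [1;2;0]; SMulL 13;
     SRelabel 14 4 [1;2;3;0]; SMulL 15; SRelabel 16 5 [1;2;3;4;0];
     SRelabel 17 5 [0;2;1;3;4]; STrans 11 18; SRelabel 19 5 [1;0;3;2;4]; STrans 9 20]);
  ([1;3;2;0;4], Comm,
    [SRelabel 0 4 [0;1;2;2;3]; SContr 1 2 2 1; SRelabel 2 3 [0;1;0;2]; SMulR 3;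
     SRelabel 4 3 [0;1;2;2]; SContr 5 2 2 2; SRelabel 6 2 [0;1;0]],
    [SMulR 0; SMulR 1; SMulR 2; SMulL 2; SRelabel 4 5 [1;2;3;4;0];
     SRelabel 5 5 [1;0;2;3;4]; STrans 3 6; SMulL 1; SRelabel 8 4 [1;2;3;0]; SMulL 9;
     SRelabel 10 5 [1;2;3;4;0]; SRelabel 5 5 [0;1;3;2;4]; STrans 11 12;
     SRelabel 13 5 [1;2;0;3;4]; STrans 7 14]);
  ([1;3;2;4;0], Comm,
    [SRelabel 0 4 [0;1;2;2;3]; SContr 1 2 2 1; SRelabel 2 3 [0;1;0;2]; SMulR 3;
     SRelabel 4 3 [0;1;2;2]; SRelabel 3 3 [2;0;2]; SMulL 6; SRelabel 7 3 [0;1;2;1];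
     STrans 5 8; SContr 9 2 2 2; SRelabel 10 2 [0;1;0]],
    [SMulR 0; SMulR 1; SMulR 2; SMulL 2; SRelabel 4 5 [1;2;3;4;0]; SMulL 1;
     SRelabel 6 4 [1;2;3;0]; SMulL 7; SRelabel 8 5 [1;2;3;4;0];
     SRelabel 9 5 [0;2;1;3;4]; STrans 5 10; SMulL 0; SRelabel 12 3 [1;2;0]; SMulL 13;
     SRelabel 14 4 [1;2;3;0]; SMulL 15; SRelabel 16 5 [1;2;3;4;0];
     SRelabel 17 5 [0;2;1;3;4]; STrans 5 18; SRelabel 19 5 [0;2;3;1;4]; STrans 11 20;
     SRelabel 21 5 [1;0;2;3;4]; STrans 3 22]);
  ([1;3;4;0;2], Comm,
    [SRelabel 0 4 [0;1;2;3;3]; SContr 1 3 3 1; SRelabel 2 3 [0;1;2;0]; SMulR 3;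
     SRelabel 4 3 [0;1;2;2]; SContr 5 2 2 2; SRelabel 6 2 [0;1;0]],
    [SMulR 0; SMulR 1; SMulR 2; SMulL 1; SRelabel 4 4 [1;2;3;0]; SMulL 5;
     SRelabel 6 5 [1;2;3;4;0]; SMulL 2; SRelabel 8 5 [1;2;3;4;0];
     SRelabel 9 5 [0;1;3;2;4]; STrans 7 10; SMulL 0; SRelabel 12 3 [1;2;0]; SMulL 13;
     SRelabel 14 4 [1;2;3;0]; SMulL 15; SRelabel 16 5 [1;2;3;4;0];
     SRelabel 7 5 [0;1;2;4;3]; STrans 17 18; SRelabel 19 5 [0;3;1;2;4]; STrans 11 20;
     SRelabel 21 5 [1;0;2;3;4]; STrans 3 22]);
  ([1;3;4;2;0], Comm,
    [SRelabel 0 4 [0;1;2;3;3]; SContr 1 3 3 1; SRelabel 2 3 [0;1;2;0]; SMulR 3;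
     SRelabel 4 3 [0;1;2;2]; SRelabel 3 3 [2;0;2]; SMulL 6; SRelabel 7 3 [0;1;2;1];
     STrans 5 8; SContr 9 2 2 2; SRelabel 10 2 [0;1;0]],
    [SMulR 0; SMulR 1; SMulR 2; SMulL 2; SRelabel 4 5 [1;2;3;4;0];
     SRelabel 5 5 [1;0;2;3;4]; STrans 3 6; SMulL 1; SRelabel 8 4 [1;2;3;0]; SMulL 9;
     SRelabel 10 5 [1;2;3;4;0]; SRelabel 5 5 [0;1;3;2;4]; STrans 11 12; SMulL 0;
     SRelabel 14 3 [1;2;0]; SMulL 15; SRelabel 16 4 [1;2;3;0]; SMulL 17;
     SRelabel 18 5 [1;2;3;4;0]; SRelabel 11 5 [0;1;2;4;3]; STrans 19 20;
     SRelabel 21 5 [0;3;1;2;4]; STrans 13 22; SRelabel 23 5 [1;2;0;3;4]; STrans 7 24]);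
  ([1;4;0;2;3], Comm,
    [SRelabel 0 4 [0;1;2;2;3]; SContr 1 2 2 3; SRelabel 2 3 [0;1;0;2]; SMulR 3;
     SRelabel 4 3 [0;1;2;2]; SRelabel 3 3 [2;0;2]; SMulL 6; SRelabel 7 3 [0;1;2;1];
     STrans 5 8; SContr 9 2 2 2; SRelabel 10 2 [0;1;0]],
    [SMulR 0; SMulR 1; SMulR 2; SMulL 0; SRelabel 4 3 [1;2;0]; SMulL 5;
     SRelabel 6 4 [1;2;3;0]; SMulL 7; SRelabel 8 5 [1;2;3;4;0];
     SRelabel 9 5 [1;0;2;3;4]; STrans 3 10; SMulL 1; SRelabel 12 4 [1;2;3;0]; SMulL 13;
     SRelabel 14 5 [1;2;3;4;0]; SMulL 2; SRelabel 16 5 [1;2;3;4;0];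
     SRelabel 17 5 [0;1;3;2;4]; STrans 15 18; SRelabel 19 5 [1;0;2;4;3]; STrans 11 20]);
  ([1;4;0;3;2], Comm,
    [SRelabel 0 4 [0;1;2;2;3]; SContr 1 2 2 3; SRelabel 2 3 [0;1;0;2]; SMulR 3;
     SRelabel 4 3 [0;1;2;2]; SRelabel 3 3 [2;0;2]; SMulL 6; SRelabel 7 3 [0;1;2;1];
     STrans 5 8; SContr 9 2 2 2; SRelabel 10 2 [0;1;0]],
    [SMulR 0; SMulR 1; SMulR 2; SMulL 1; SRelabel 4 4 [1;2;3;0]; SMulL 5;
     SRelabel 6 5 [1;2;3;4;0]; SMulL 0; SRelabel 8 3 [1;2;0]; SMulL 9;
     SRelabel 10 4 [1;2;3;0]; SMulL 11; SRelabel 12 5 [1;2;3;4;0];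
     SRelabel 13 5 [0;1;3;2;4]; STrans 7 14; SMulL 2; SRelabel 16 5 [1;2;3;4;0];
     SRelabel 17 5 [0;1;3;2;4]; STrans 7 18; SRelabel 19 5 [0;1;3;4;2]; STrans 15 20;
     SRelabel 21 5 [1;0;2;3;4]; STrans 3 22]);
  ([1;4;2;0;3], Comm,
    [SRelabel 0 5 [1;4;2;0;3]; STrans 0 1; SRelabel 2 4 [0;1;2;3;3]; SContr 3 3 3 0;
     SRelabel 4 3 [0;1;2;0]; SMulR 5; SMulR 6; SRelabel 7 5 [1;4;2;0;3]; STrans 0 8;
     SRelabel 9 4 [0;0;1;2;3]; SContr 10 0 0 2; SRelabel 11 3 [0;0;1;2]; SMulL 12;
     SRelabel 13 4 [1;2;3;0]; SRelabel 14 3 [0;0;1;2]; SContr 15 0 0 0;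
     SRelabel 16 2 [0;0;1]],
    [SMulR 0; SMulR 1; SMulR 2; SMulL 2; SRelabel 4 5 [1;2;3;4;0]; SMulL 0;
     SRelabel 6 3 [1;2;0]; SMulL 7; SRelabel 8 4 [1;2;3;0]; SMulL 9;
     SRelabel 10 5 [1;2;3;4;0]; SRelabel 11 5 [0;2;1;3;4]; STrans 5 12; SMulL 1;
     SRelabel 14 4 [1;2;3;0]; SMulL 15; SRelabel 16 5 [1;2;3;4;0];
     SRelabel 5 5 [0;1;3;2;4]; STrans 17 18; SRelabel 19 5 [0;2;1;4;3]; STrans 13 20;
     SRelabel 21 5 [1;0;2;3;4]; STrans 3 22]);
  ([1;4;2;3;0], Comm,
    [SRelabel 0 4 [0;1;2;2;3]; SContr 1 2 2 2; SRelabel 2 3 [0;1;0;2]; SMulR 3;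
     SRelabel 4 3 [0;1;2;2]; SRelabel 3 3 [2;0;2]; SMulL 6; SRelabel 7 3 [0;1;2;1];
     STrans 5 8; SContr 9 2 2 2; SRelabel 10 2 [0;1;0]],
    [SMulR 0; SMulR 1; SMulR 2; SMulL 2; SRelabel 4 5 [1;2;3;4;0];
     SRelabel 5 5 [1;0;2;3;4]; STrans 3 6; SMulL 1; SRelabel 8 4 [1;2;3;0]; SMulL 9;
     SRelabel 10 5 [1;2;3;4;0]; SMulL 0; SRelabel 12 3 [1;2;0]; SMulL 13;
     SRelabel 14 4 [1;2;3;0]; SMulL 15; SRelabel 16 5 [1;2;3;4;0];
     SRelabel 17 5 [0;1;3;2;4]; STrans 11 18; SRelabel 5 5 [0;1;3;2;4]; STrans 11 20;
     SRelabel 21 5 [0;1;3;4;2]; STrans 19 22; SRelabel 23 5 [1;2;0;3;4]; STrans 7 24]);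
  ([1;4;3;0;2], Comm,
    [SRelabel 0 4 [0;1;2;3;3]; SContr 1 3 3 1; SRelabel 2 3 [0;1;2;0]; SMulR 3;
     SRelabel 4 3 [0;1;2;2]; SContr 5 2 2 2; SRelabel 6 2 [0;1;0]],
    [SMulR 0; SMulR 1; SMulR 2; SMulL 1; SRelabel 4 4 [1;2;3;0]; SMulL 5;
     SRelabel 6 5 [1;2;3;4;0]; SRelabel 7 5 [1;0;2;3;4]; STrans 3 8; SMulL 2;
     SRelabel 10 5 [1;2;3;4;0]; SMulL 0; SRelabel 12 3 [1;2;0]; SMulL 13;
     SRelabel 14 4 [1;2;3;0]; SMulL 15; SRelabel 16 5 [1;2;3;4;0];
     SRelabel 17 5 [0;2;1;3;4]; STrans 11 18; SRelabel 11 5 [0;1;3;2;4]; STrans 7 20;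
     SRelabel 21 5 [0;2;1;4;3]; STrans 19 22; SRelabel 23 5 [1;0;3;2;4]; STrans 9 24]);
  ([1;4;3;2;0], Comm,
    [SRelabel 0 4 [0;1;2;3;3]; SContr 1 3 3 1; SRelabel 2 3 [0;1;2;0]; SMulR 3;
     SRelabel 4 3 [0;1;2;2]; SRelabel 3 3 [2;0;2]; SMulL 6; SRelabel 7 3 [0;1;2;1];
     STrans 5 8; SContr 9 2 2 2; SRelabel 10 2 [0;1;0]],
    [SMulR 0; SMulR 1; SMulR 2; SMulL 2; SRelabel 4 5 [1;2;3;4;0]; SMulL 1;
     SRelabel 6 4 [1;2;3;0]; SMulL 7; SRelabel 8 5 [1;2;3;4;0];
     SRelabel 9 5 [0;2;1;3;4]; STrans 5 10; SRelabel 11 5 [1;0;2;3;4]; STrans 3 12;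
     SMulL 0; SRelabel 14 3 [1;2;0]; SMulL 15; SRelabel 16 4 [1;2;3;0]; SMulL 17;
     SRelabel 18 5 [1;2;3;4;0]; SRelabel 19 5 [0;2;1;3;4]; STrans 5 20;
     SRelabel 5 5 [0;1;3;2;4]; STrans 9 22; SRelabel 23 5 [0;2;1;4;3]; STrans 21 24;
     SRelabel 25 5 [1;2;3;0;4]; STrans 13 26]);
  ([2;0;1;3;4], Comm,
    [SStar 0; SRelabel 1 5 [4;3;2;1;0]; SRelabel 2 4 [0;0;1;2;3]; SContr 3 0 0 0;
     SRelabel 4 3 [0;0;1;2]; SMulR 5; SRelabel 6 3 [0;1;2;2]; SRelabel 5 3 [2;0;2];
     SMulL 8; SRelabel 9 3 [0;1;2;1]; STrans 7 10; SContr 11 2 2 2;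
     SRelabel 12 2 [0;1;0]],
    [SMulR 0; SMulR 1; SMulL 2; SRelabel 3 5 [1;2;3;4;0]; SMulR 2;
     SRelabel 5 5 [0;2;1;3;4]; STrans 4 6]);
  ([2;0;1;4;3], Comm,
    [SRelabel 0 4 [0;0;1;2;3]; SContr 1 0 0 1; SRelabel 2 3 [0;0;1;2]; SMulL 3;
     SRelabel 4 4 [1;2;3;0]; SRelabel 5 3 [0;0;1;2]; SContr 6 0 0 0;
     SRelabel 7 2 [0;0;1]],
    [SMulR 0; SMulR 1; SMulL 2; SRelabel 3 5 [1;2;3;4;0]; SMulR 2; SMulL 0;
     SRelabel 6 3 [1;2;0]; SMulL 7; SRelabel 8 4 [1;2;3;0]; SMulL 9;
     SRelabel 10 5 [1;2;3;4;0]; SRelabel 11 5 [1;0;2;3;4]; STrans 5 12;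
     SRelabel 13 5 [0;2;1;3;4]; STrans 4 14]);
  ([2;0;3;1;4], Comm,
    [SMulR 0; SRelabel 1 5 [0;1;2;3;4;4]; SContr 2 4 4 4; SRelabel 3 4 [0;1;2;3;0];
     SRelabel 4 4 [2;0;3;1]; STrans 4 5; SRelabel 6 3 [0;1;2;2]; SContr 7 2 2 0;
     SRelabel 8 2 [0;1;0]],
    [SMulR 0; SMulR 1; SMulL 2; SRelabel 3 5 [1;2;3;4;0]; SMulR 2; SMulL 1;
     SRelabel 6 4 [1;2;3;0]; SMulL 7; SRelabel 8 5 [1;2;3;4;0];
     SRelabel 9 5 [1;0;2;3;4]; STrans 5 10; SRelabel 11 5 [0;2;1;3;4]; STrans 4 12]);
  ([2;0;3;4;1], Comm,
    [SRelabel 0 5 [2;0;3;4;1]; STrans 0 1; SRelabel 2 4 [0;0;1;2;3]; SContr 3 0 0 3;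
     SRelabel 4 3 [0;0;1;2]; SMulR 5; SRelabel 6 3 [0;1;2;2]; SContr 7 2 2 2;
     SRelabel 8 2 [0;1;0]],
    [SMulR 0; SMulR 1; SMulL 2; SRelabel 3 5 [1;2;3;4;0]; SMulR 2;
     SRelabel 5 5 [0;2;1;3;4]; STrans 4 6; SMulL 1; SRelabel 8 4 [1;2;3;0]; SMulL 9;
     SRelabel 10 5 [1;2;3;4;0]; SMulL 0; SRelabel 12 3 [1;2;0]; SMulL 13;
     SRelabel 14 4 [1;2;3;0]; SMulL 15; SRelabel 16 5 [1;2;3;4;0];
     SRelabel 17 5 [0;1;3;2;4]; STrans 11 18; SRelabel 19 5 [2;0;1;3;4]; STrans 7 20]);
  ([2;0;4;1;3], Comm,
    [SRelabel 0 5 [2;0;4;1;3]; STrans 0 1; SRelabel 2 5 [2;0;4;1;3]; STrans 0 3;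
     SRelabel 4 4 [0;1;2;3;3]; SContr 5 3 3 0; SRelabel 6 3 [0;1;2;0]; SMulR 7;
     SRelabel 8 3 [0;1;2;2]; SRelabel 7 3 [2;0;2]; SMulL 10; SRelabel 11 3 [0;1;2;1];
     STrans 9 12; SContr 13 2 2 2; SRelabel 14 2 [0;1;0]],
    [SMulR 0; SMulR 1; SMulL 2; SRelabel 3 5 [1;2;3;4;0]; SMulR 2;
     SRelabel 5 5 [0;2;1;3;4]; STrans 4 6; SMulL 0; SRelabel 8 3 [1;2;0]; SMulL 9;
     SRelabel 10 4 [1;2;3;0]; SMulL 11; SRelabel 12 5 [1;2;3;4;0]; SMulL 1;
     SRelabel 14 4 [1;2;3;0]; SMulL 15; SRelabel 16 5 [1;2;3;4;0];
     SRelabel 17 5 [0;1;2;4;3]; STrans 13 18; SRelabel 19 5 [2;0;1;3;4]; STrans 7 20]);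
  ([2;0;4;3;1], Comm,
    [SStar 0; SRelabel 1 5 [4;3;2;1;0]; SRelabel 2 4 [0;0;1;2;3]; SContr 3 0 0 1;
     SRelabel 4 3 [0;0;1;2]; SMulR 5; SRelabel 6 3 [0;1;2;2]; SRelabel 5 3 [2;0;2];
     SMulL 8; SRelabel 9 3 [0;1;2;1]; STrans 7 10; SContr 11 2 2 2;
     SRelabel 12 2 [0;1;0]],
    [SMulR 0; SMulR 1; SMulL 2; SRelabel 3 5 [1;2;3;4;0]; SMulR 2; SMulL 1;
     SRelabel 6 4 [1;2;3;0]; SMulL 7; SRelabel 8 5 [1;2;3;4;0];
     SRelabel 9 5 [1;0;2;3;4]; STrans 5 10; SMulL 0; SRelabel 12 3 [1;2;0]; SMulL 13;
     SRelabel 14 4 [1;2;3;0]; SMulL 15; SRelabel 16 5 [1;2;3;4;0];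
     SRelabel 9 5 [0;1;2;4;3]; STrans 17 18; SRelabel 19 5 [1;0;3;2;4]; STrans 11 20;
     SRelabel 21 5 [0;2;1;3;4]; STrans 4 22]);
  ([2;1;0;3;4], HalfComm,
    [SRelabel 0 4 [0;1;2;3;3]; SContr 1 3 3 3; SRelabel 2 3 [0;1;2;0]],
    [SMulR 0; SMulR 1]);
  ([2;1;0;4;3], Comm,
    [SRelabel 0 4 [0;1;1;2;3]; SContr 1 1 1 0; SRelabel 2 3 [0;0;1;2]; SMulL 3;
     SRelabel 4 4 [1;2;3;0]; SRelabel 5 3 [0;0;1;2]; SContr 6 0 0 0;
     SRelabel 7 2 [0;0;1]],
    [SMulR 0; SMulR 1; SMulR 2; SMulL 2; SRelabel 4 5 [1;2;3;4;0];
     SRelabel 5 5 [1;0;2;3;4]; STrans 3 6; SMulL 0; SRelabel 8 3 [1;2;0]; SMulL 9;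
     SRelabel 10 4 [1;2;3;0]; SMulL 11; SRelabel 12 5 [1;2;3;4;0];
     SRelabel 13 5 [1;0;2;3;4]; STrans 3 14; SRelabel 15 5 [1;2;0;3;4]; STrans 7 16]);
  ([2;1;3;0;4], Comm,
    [SRelabel 0 4 [0;1;1;2;3]; SContr 1 1 1 0; SRelabel 2 3 [0;0;1;2]; SMulR 3;
     SRelabel 4 3 [0;1;2;2]; SContr 5 2 2 2; SRelabel 6 2 [0;1;0]],
    [SMulR 0; SMulR 1; SMulR 2; SMulL 2; SRelabel 4 5 [1;2;3;4;0];
     SRelabel 5 5 [1;0;2;3;4]; STrans 3 6; SMulL 1; SRelabel 8 4 [1;2;3;0]; SMulL 9;
     SRelabel 10 5 [1;2;3;4;0]; SRelabel 11 5 [1;0;2;3;4]; STrans 3 12;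
     SRelabel 13 5 [1;2;0;3;4]; STrans 7 14]);
  ([2;1;3;4;0], Comm,
    [SRelabel 0 4 [0;1;1;2;3]; SContr 1 1 1 0; SRelabel 2 3 [0;0;1;2]; SMulR 3;
     SRelabel 4 3 [0;1;2;2]; SRelabel 3 3 [2;0;2]; SMulL 6; SRelabel 7 3 [0;1;2;1];
     STrans 5 8; SContr 9 2 2 2; SRelabel 10 2 [0;1;0]],
    [SMulR 0; SMulR 1; SMulR 2; SMulL 2; SRelabel 4 5 [1;2;3;4;0];
     SRelabel 3 5 [0;2;1;3;4]; STrans 5 6; SMulL 1; SRelabel 8 4 [1;2;3;0]; SMulL 9;
     SRelabel 10 5 [1;2;3;4;0]; SMulL 0; SRelabel 12 3 [1;2;0]; SMulL 13;
     SRelabel 14 4 [1;2;3;0]; SMulL 15; SRelabel 16 5 [1;2;3;4;0];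
     SRelabel 17 5 [0;1;3;2;4]; STrans 11 18; SRelabel 19 5 [2;0;1;3;4]; STrans 7 20;
     SRelabel 21 5 [1;0;2;3;4]; STrans 3 22]);
  ([2;1;4;0;3], Comm,
    [SStar 0; SRelabel 1 5 [4;3;2;1;0]; SRelabel 2 4 [0;1;2;2;3]; SContr 3 2 2 3;
     SRelabel 4 3 [0;1;0;2]; SMulR 5; SRelabel 6 3 [0;1;2;2]; SRelabel 5 3 [2;0;2];
     SMulL 8; SRelabel 9 3 [0;1;2;1]; STrans 7 10; SContr 11 2 2 2;
     SRelabel 12 2 [0;1;0]],
    [SMulR 0; SMulR 1; SMulR 2; SMulL 2; SRelabel 4 5 [1;2;3;4;0];
     SRelabel 3 5 [0;2;1;3;4]; STrans 5 6; SMulL 0; SRelabel 8 3 [1;2;0]; SMulL 9;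
     SRelabel 10 4 [1;2;3;0]; SMulL 11; SRelabel 12 5 [1;2;3;4;0]; SMulL 1;
     SRelabel 14 4 [1;2;3;0]; SMulL 15; SRelabel 16 5 [1;2;3;4;0];
     SRelabel 17 5 [0;1;2;4;3]; STrans 13 18; SRelabel 19 5 [2;0;1;3;4]; STrans 7 20;
     SRelabel 21 5 [1;0;2;3;4]; STrans 3 22]);
  ([2;1;4;3;0], HalfComm,
    [SRelabel 0 4 [0;1;1;2;3]; SContr 1 1 1 0; SRelabel 2 3 [0;0;1;2]],
    [SMulR 0; SMulR 1; SMulL 0; SRelabel 3 4 [1;2;3;0]; SMulL 4; SRelabel 5 5 [1;2;3;4;0];
     SRelabel 6 5 [2;1;0;3;4]; STrans 2 7]);
  ([2;3;0;1;4], HalfComm,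
    [SMulR 0; SRelabel 1 5 [0;1;2;3;4;4]; SContr 2 4 4 4; SRelabel 3 4 [0;1;2;3;0];
     SMulR 4; SRelabel 5 4 [0;1;2;3;3]; SRelabel 4 4 [3;0;1;3]; SMulL 7;
     SRelabel 8 4 [0;1;2;3;2]; STrans 6 9; SContr 10 3 3 2; SRelabel 11 3 [0;1;2;0]],
    [SMulR 0; SMulR 1; SMulL 1; SRelabel 3 5 [1;2;3;4;0]; SRelabel 4 5 [2;1;0;3;4];
     STrans 2 5]);
  ([2;3;0;4;1], Comm,
    [SRelabel 0 4 [0;1;2;2;3]; SContr 1 2 2 0; SRelabel 2 3 [0;1;0;2]; SMulL 3;
     SRelabel 4 4 [1;2;3;0]; SRelabel 5 3 [0;0;1;2]; SContr 6 0 0 0;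
     SRelabel 7 2 [0;0;1]],
    [SMulR 0; SMulR 1; SMulL 2; SRelabel 3 5 [1;2;3;4;0]; SMulR 2; SMulL 1;
     SRelabel 6 4 [1;2;3;0]; SMulL 7; SRelabel 8 5 [1;2;3;4;0];
     SRelabel 9 5 [1;0;2;3;4]; STrans 5 10; SMulL 0; SRelabel 12 3 [1;2;0]; SMulL 13;
     SRelabel 14 4 [1;2;3;0]; SMulL 15; SRelabel 16 5 [1;2;3;4;0];
     SRelabel 17 5 [0;2;1;3;4]; STrans 4 18; SRelabel 19 5 [1;0;3;2;4]; STrans 11 20;
     SRelabel 21 5 [0;2;1;3;4]; STrans 4 22]);
  ([2;3;1;0;4], Comm,
    [SRelabel 0 4 [0;1;2;2;3]; SContr 1 2 2 0; SRelabel 2 3 [0;1;0;2]; SMulR 3;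
     SRelabel 4 3 [0;1;2;2]; SContr 5 2 2 2; SRelabel 6 2 [0;1;0]],
    [SMulR 0; SMulR 1; SMulR 2; SMulL 2; SRelabel 4 5 [1;2;3;4;0];
     SRelabel 3 5 [0;2;1;3;4]; STrans 5 6; SMulL 1; SRelabel 8 4 [1;2;3;0]; SMulL 9;
     SRelabel 10 5 [1;2;3;4;0]; SRelabel 5 5 [0;1;3;2;4]; STrans 11 12;
     SRelabel 13 5 [2;0;1;3;4]; STrans 7 14; SRelabel 15 5 [1;0;2;3;4]; STrans 3 16]);
  ([2;3;1;4;0], Comm,
    [SRelabel 0 4 [0;1;2;2;3]; SContr 1 2 2 0; SRelabel 2 3 [0;1;0;2]; SMulR 3;
     SRelabel 4 3 [0;1;2;2]; SRelabel 3 3 [2;0;2]; SMulL 6; SRelabel 7 3 [0;1;2;1];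
     STrans 5 8; SContr 9 2 2 2; SRelabel 10 2 [0;1;0]],
    [SMulR 0; SMulR 1; SMulR 2; SMulL 2; SRelabel 4 5 [1;2;3;4;0];
     SRelabel 5 5 [1;0;2;3;4]; STrans 3 6; SMulL 1; SRelabel 8 4 [1;2;3;0]; SMulL 9;
     SRelabel 10 5 [1;2;3;4;0]; SRelabel 11 5 [1;0;2;3;4]; STrans 3 12; SMulL 0;
     SRelabel 14 3 [1;2;0]; SMulL 15; SRelabel 16 4 [1;2;3;0]; SMulL 17;
     SRelabel 18 5 [1;2;3;4;0]; SRelabel 19 5 [0;2;1;3;4]; STrans 5 20;
     SRelabel 21 5 [1;0;3;2;4]; STrans 13 22; SRelabel 23 5 [1;2;0;3;4]; STrans 7 24]);
  ([2;3;4;0;1], Comm,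
    [SStar 0; SRelabel 1 5 [4;3;2;1;0]; SRelabel 2 4 [0;0;1;2;3]; SContr 3 0 0 2;
     SRelabel 4 3 [0;0;1;2]; SMulR 5; SRelabel 6 3 [0;1;2;2]; SRelabel 5 3 [2;0;2];
     SMulL 8; SRelabel 9 3 [0;1;2;1]; STrans 7 10; SContr 11 2 2 2;
     SRelabel 12 2 [0;1;0]],
    [SMulR 0; SMulR 1; SMulL 2; SRelabel 3 5 [1;2;3;4;0]; SMulR 2;
     SRelabel 5 5 [0;2;1;3;4]; STrans 4 6; SMulL 1; SRelabel 8 4 [1;2;3;0]; SMulL 9;
     SRelabel 10 5 [1;2;3;4;0]; SRelabel 4 5 [0;1;3;2;4]; STrans 11 12; SMulL 0;
     SRelabel 14 3 [1;2;0]; SMulL 15; SRelabel 16 4 [1;2;3;0]; SMulL 17;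
     SRelabel 18 5 [1;2;3;4;0]; SRelabel 11 5 [0;1;2;4;3]; STrans 19 20;
     SRelabel 21 5 [0;3;1;2;4]; STrans 13 22; SRelabel 23 5 [2;0;1;3;4]; STrans 7 24]);
  ([2;3;4;1;0], HalfComm,
    [SRelabel 0 4 [0;1;2;2;3]; SContr 1 2 2 0; SRelabel 2 3 [0;1;0;2]],
    [SMulR 0; SMulR 1; SMulL 1; SRelabel 3 5 [1;2;3;4;0]; SMulL 0; SRelabel 5 4 [1;2;3;0];
     SMulL 6; SRelabel 7 5 [1;2;3;4;0]; SRelabel 8 5 [0;3;2;1;4]; STrans 4 9;
     SRelabel 10 5 [2;1;0;3;4]; STrans 2 11]);
  ([2;4;0;1;3], Comm,
    [SRelabel 0 4 [0;0;1;2;3]; SContr 1 0 0 2; SRelabel 2 3 [0;0;1;2]; SMulL 3;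
     SRelabel 4 4 [1;2;3;0]; SRelabel 5 3 [0;0;1;2]; SContr 6 0 0 0;
     SRelabel 7 2 [0;0;1]],
    [SMulR 0; SMulR 1; SMulL 2; SRelabel 3 5 [1;2;3;4;0]; SMulR 2; SMulL 0;
     SRelabel 6 3 [1;2;0]; SMulL 7; SRelabel 8 4 [1;2;3;0]; SMulL 9;
     SRelabel 10 5 [1;2;3;4;0]; SRelabel 11 5 [1;0;2;3;4]; STrans 5 12; SMulL 1;
     SRelabel 14 4 [1;2;3;0]; SMulL 15; SRelabel 16 5 [1;2;3;4;0];
     SRelabel 4 5 [0;1;3;2;4]; STrans 17 18; SRelabel 19 5 [1;0;2;4;3]; STrans 13 20;
     SRelabel 21 5 [0;2;1;3;4]; STrans 4 22]);
  ([2;4;0;3;1], Comm,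
    [SStar 0; SRelabel 1 5 [4;3;2;1;0]; SRelabel 2 5 [2;4;0;3;1]; STrans 0 3;
     SRelabel 4 4 [0;1;2;3;3]; SContr 5 3 3 0; SRelabel 6 3 [0;1;2;0]; SMulR 7;
     SRelabel 8 3 [0;1;2;2]; SRelabel 7 3 [2;0;2]; SMulL 10; SRelabel 11 3 [0;1;2;1];
     STrans 9 12; SContr 13 2 2 2; SRelabel 14 2 [0;1;0]],
    [SMulR 0; SMulR 1; SMulL 2; SRelabel 3 5 [1;2;3;4;0]; SMulR 2;
     SRelabel 5 5 [0;2;1;3;4]; STrans 4 6; SMulL 1; SRelabel 8 4 [1;2;3;0]; SMulL 9;
     SRelabel 10 5 [1;2;3;4;0]; SMulL 0; SRelabel 12 3 [1;2;0]; SMulL 13;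
     SRelabel 14 4 [1;2;3;0]; SMulL 15; SRelabel 16 5 [1;2;3;4;0];
     SRelabel 17 5 [0;1;3;2;4]; STrans 11 18; SRelabel 4 5 [0;1;3;2;4]; STrans 11 20;
     SRelabel 21 5 [0;1;3;4;2]; STrans 19 22; SRelabel 23 5 [2;0;1;3;4]; STrans 7 24]);
  ([2;4;1;0;3], Comm,
    [SRelabel 0 4 [0;0;1;2;3]; SContr 1 0 0 2; SRelabel 2 3 [0;0;1;2]; SMulL 3;
     SRelabel 4 4 [1;2;3;0]; SRelabel 5 3 [0;0;1;2]; SContr 6 0 0 0;
     SRelabel 7 2 [0;0;1]],
    [SMulR 0; SMulR 1; SMulR 2; SMulL 2; SRelabel 4 5 [1;2;3;4;0];
     SRelabel 5 5 [1;0;2;3;4]; STrans 3 6; SMulL 0; SRelabel 8 3 [1;2;0]; SMulL 9;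
     SRelabel 10 4 [1;2;3;0]; SMulL 11; SRelabel 12 5 [1;2;3;4;0];
     SRelabel 13 5 [1;0;2;3;4]; STrans 3 14; SMulL 1; SRelabel 16 4 [1;2;3;0];
     SMulL 17; SRelabel 18 5 [1;2;3;4;0]; SRelabel 5 5 [0;1;3;2;4]; STrans 19 20;
     SRelabel 21 5 [1;0;2;4;3]; STrans 15 22; SRelabel 23 5 [1;2;0;3;4]; STrans 7 24]);
  ([2;4;1;3;0], Comm,
    [SRelabel 0 5 [2;4;1;3;0]; STrans 0 1; SRelabel 2 4 [0;1;2;3;3]; SContr 3 3 3 2;
     SRelabel 4 3 [0;1;2;0]; SMulR 5; SRelabel 6 3 [0;1;2;2]; SContr 7 2 2 2;
     SRelabel 8 2 [0;1;0]],
    [SMulR 0; SMulR 1; SMulR 2; SMulL 2; SRelabel 4 5 [1;2;3;4;0];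
     SRelabel 3 5 [0;2;1;3;4]; STrans 5 6; SRelabel 7 5 [1;0;2;3;4]; STrans 3 8;
     SMulL 1; SRelabel 10 4 [1;2;3;0]; SMulL 11; SRelabel 12 5 [1;2;3;4;0]; SMulL 0;
     SRelabel 14 3 [1;2;0]; SMulL 15; SRelabel 16 4 [1;2;3;0]; SMulL 17;
     SRelabel 18 5 [1;2;3;4;0]; SRelabel 19 5 [0;1;3;2;4]; STrans 13 20;
     SRelabel 5 5 [0;1;3;2;4]; STrans 13 22; SRelabel 23 5 [0;1;3;4;2]; STrans 21 24;
     SRelabel 25 5 [2;1;0;3;4]; STrans 9 26]);
  ([2;4;3;0;1], Comm,
    [SRelabel 0 4 [0;0;1;2;3]; SContr 1 0 0 3; SRelabel 2 3 [0;0;1;2]; SMulL 3;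
     SRelabel 4 4 [1;2;3;0]; SRelabel 5 3 [0;0;1;2]; SContr 6 0 0 0;
     SRelabel 7 2 [0;0;1]],
    [SMulR 0; SMulR 1; SMulL 2; SRelabel 3 5 [1;2;3;4;0]; SMulR 2; SMulL 1;
     SRelabel 6 4 [1;2;3;0]; SMulL 7; SRelabel 8 5 [1;2;3;4;0];
     SRelabel 9 5 [1;0;2;3;4]; STrans 5 10; SRelabel 11 5 [0;2;1;3;4]; STrans 4 12;
     SMulL 0; SRelabel 14 3 [1;2;0]; SMulL 15; SRelabel 16 4 [1;2;3;0]; SMulL 17;
     SRelabel 18 5 [1;2;3;4;0]; SRelabel 19 5 [0;2;1;3;4]; STrans 4 20;
     SRelabel 4 5 [0;1;3;2;4]; STrans 9 22; SRelabel 23 5 [0;2;1;4;3]; STrans 21 24;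
     SRelabel 25 5 [2;0;3;1;4]; STrans 13 26]);
  ([2;4;3;1;0], Comm,
    [SRelabel 0 4 [0;0;1;2;3]; SContr 1 0 0 3; SRelabel 2 3 [0;0;1;2]; SMulL 3;
     SRelabel 4 4 [1;2;3;0]; SRelabel 5 3 [0;0;1;2]; SContr 6 0 0 0;
     SRelabel 7 2 [0;0;1]],
    [SMulR 0; SMulR 1; SMulR 2; SMulL 2; SRelabel 4 5 [1;2;3;4;0];
     SRelabel 5 5 [1;0;2;3;4]; STrans 3 6; SMulL 1; SRelabel 8 4 [1;2;3;0]; SMulL 9;
     SRelabel 10 5 [1;2;3;4;0]; SRelabel 11 5 [1;0;2;3;4]; STrans 3 12;
     SRelabel 13 5 [1;2;0;3;4]; STrans 7 14; SMulL 0; SRelabel 16 3 [1;2;0]; SMulL 17;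
     SRelabel 18 4 [1;2;3;0]; SMulL 19; SRelabel 20 5 [1;2;3;4;0];
     SRelabel 21 5 [0;2;1;3;4]; STrans 5 22; SRelabel 5 5 [0;1;3;2;4]; STrans 11 24;
     SRelabel 25 5 [0;2;1;4;3]; STrans 23 26; SRelabel 27 5 [2;1;3;0;4]; STrans 15 28]);
  ([3;0;1;2;4], Comm,
    [SRelabel 0 4 [0;0;1;2;3]; SContr 1 0 0 1; SRelabel 2 3 [0;0;1;2]; SMulR 3;
     SRelabel 4 3 [0;1;2;2]; SContr 5 2 2 2; SRelabel 6 2 [0;1;0]],
    [SMulR 0; SMulL 1; SRelabel 2 4 [1;2;3;0]; SMulL 3; SRelabel 4 5 [1;2;3;4;0]; SMulR 1;
     SMulL 6; SRelabel 7 5 [1;2;3;4;0]; SMulR 6; SRelabel 9 5 [0;2;1;3;4]; STrans 8 10;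
     SRelabel 11 5 [0;1;3;2;4]; STrans 5 12]);
  ([3;0;1;4;2], Comm,
    [SRelabel 0 4 [0;0;1;2;3]; SContr 1 0 0 1; SRelabel 2 3 [0;0;1;2]; SMulR 3;
     SRelabel 4 3 [0;1;2;2]; SRelabel 3 3 [2;0;2]; SMulL 6; SRelabel 7 3 [0;1;2;1];
     STrans 5 8; SContr 9 2 2 2; SRelabel 10 2 [0;1;0]],
    [SMulR 0; SMulL 1; SRelabel 2 4 [1;2;3;0]; SMulL 3; SRelabel 4 5 [1;2;3;4;0]; SMulR 1;
     SMulL 6; SRelabel 7 5 [1;2;3;4;0]; SRelabel 8 5 [0;1;3;2;4]; STrans 5 9; SMulR 6;
     SMulL 0; SRelabel 12 3 [1;2;0]; SMulL 13; SRelabel 14 4 [1;2;3;0]; SMulL 15;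
     SRelabel 16 5 [1;2;3;4;0]; SRelabel 17 5 [1;0;2;3;4]; STrans 11 18;
     SRelabel 19 5 [0;3;1;2;4]; STrans 10 20]);
  ([3;0;2;1;4], Comm,
    [SRelabel 0 4 [0;1;1;2;3]; SContr 1 1 1 2; SRelabel 2 3 [0;0;1;2]; SMulR 3;
     SRelabel 4 3 [0;1;2;2]; SContr 5 2 2 2; SRelabel 6 2 [0;1;0]],
    [SMulR 0; SMulR 1; SMulL 2; SRelabel 3 5 [1;2;3;4;0]; SMulL 1; SRelabel 5 4 [1;2;3;0];
     SMulL 6; SRelabel 7 5 [1;2;3;4;0]; SRelabel 8 5 [0;2;1;3;4]; STrans 4 9; SMulR 2;
     SRelabel 11 5 [0;2;1;3;4]; STrans 4 12; SRelabel 13 5 [0;2;3;1;4]; STrans 10 14]);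
  ([3;0;2;4;1], Comm,
    [SRelabel 0 5 [3;0;2;4;1]; STrans 0 1; SRelabel 2 5 [3;0;2;4;1]; STrans 0 3;
     SRelabel 2 4 [0;1;2;3;3]; SContr 5 3 3 0; SRelabel 6 3 [0;1;2;0]; SMulR 7;
     SMulR 8; SRelabel 9 5 [1;4;2;0;3]; STrans 4 10; SRelabel 11 4 [0;0;1;2;3];
     SContr 12 0 0 2; SRelabel 13 3 [0;0;1;2]; SMulL 14; SRelabel 15 4 [1;2;3;0];
     SRelabel 16 3 [0;0;1;2]; SContr 17 0 0 0; SRelabel 18 2 [0;0;1]],
    [SMulR 0; SMulR 1; SMulL 2; SRelabel 3 5 [1;2;3;4;0]; SMulL 1; SRelabel 5 4 [1;2;3;0];
     SMulL 6; SRelabel 7 5 [1;2;3;4;0]; SRelabel 4 5 [0;1;3;2;4]; STrans 8 9; SMulR 2;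
     SMulL 0; SRelabel 12 3 [1;2;0]; SMulL 13; SRelabel 14 4 [1;2;3;0]; SMulL 15;
     SRelabel 16 5 [1;2;3;4;0]; SRelabel 17 5 [1;0;2;3;4]; STrans 11 18;
     SRelabel 19 5 [0;3;1;2;4]; STrans 10 20; SRelabel 21 5 [0;2;1;3;4]; STrans 4 22]);
  ([3;0;4;1;2], Comm,
    [SRelabel 0 4 [0;1;1;2;3]; SContr 1 1 1 3; SRelabel 2 3 [0;0;1;2]; SMulR 3;
     SRelabel 4 3 [0;1;2;2]; SContr 5 2 2 2; SRelabel 6 2 [0;1;0]],
    [SMulR 0; SMulL 1; SRelabel 2 4 [1;2;3;0]; SMulL 3; SRelabel 4 5 [1;2;3;4;0]; SMulR 1;
     SMulL 6; SRelabel 7 5 [1;2;3;4;0]; SMulR 6; SRelabel 9 5 [0;2;1;3;4]; STrans 8 10;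
     SMulL 0; SRelabel 12 3 [1;2;0]; SMulL 13; SRelabel 14 4 [1;2;3;0]; SMulL 15;
     SRelabel 16 5 [1;2;3;4;0]; SRelabel 5 5 [0;1;2;4;3]; STrans 17 18;
     SRelabel 19 5 [2;0;1;3;4]; STrans 11 20; SRelabel 21 5 [0;1;3;2;4]; STrans 5 22]);
  ([3;0;4;2;1], Comm,
    [SRelabel 0 4 [0;1;1;2;3]; SContr 1 1 1 3; SRelabel 2 3 [0;0;1;2]; SMulR 3;
     SRelabel 4 3 [0;1;2;2]; SContr 5 2 2 2; SRelabel 6 2 [0;1;0]],
    [SMulR 0; SMulR 1; SMulL 2; SRelabel 3 5 [1;2;3;4;0]; SMulL 1; SRelabel 5 4 [1;2;3;0];
     SMulL 6; SRelabel 7 5 [1;2;3;4;0]; SRelabel 8 5 [0;2;1;3;4]; STrans 4 9; SMulR 2;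
     SRelabel 11 5 [0;2;1;3;4]; STrans 4 12; SMulL 0; SRelabel 14 3 [1;2;0]; SMulL 15;
     SRelabel 16 4 [1;2;3;0]; SMulL 17; SRelabel 18 5 [1;2;3;4;0];
     SRelabel 8 5 [0;1;2;4;3]; STrans 19 20; SRelabel 21 5 [2;0;1;3;4]; STrans 13 22;
     SRelabel 23 5 [0;2;3;1;4]; STrans 10 24]);
  ([3;1;0;2;4], Comm,
    [SRelabel 0 4 [0;0;1;2;3]; SContr 1 0 0 1; SRelabel 2 3 [0;0;1;2]; SMulR 3;
     SRelabel 4 3 [0;1;2;2]; SContr 5 2 2 2; SRelabel 6 2 [0;1;0]],
    [SMulR 0; SMulR 1; SMulR 2; SMulL 1; SRelabel 4 4 [1;2;3;0]; SMulL 5;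
     SRelabel 6 5 [1;2;3;4;0]; SRelabel 7 5 [1;0;2;3;4]; STrans 3 8; SMulL 2;
     SRelabel 10 5 [1;2;3;4;0]; SRelabel 3 5 [0;2;1;3;4]; STrans 11 12;
     SRelabel 13 5 [1;0;3;2;4]; STrans 9 14]);
  ([3;1;0;4;2], Comm,
    [SRelabel 0 4 [0;0;1;2;3]; SContr 1 0 0 1; SRelabel 2 3 [0;0;1;2]; SMulR 3;
     SRelabel 4 3 [0;1;2;2]; SRelabel 3 3 [2;0;2]; SMulL 6; SRelabel 7 3 [0;1;2;1];
     STrans 5 8; SContr 9 2 2 2; SRelabel 10 2 [0;1;0]],
    [SMulR 0; SMulR 1; SMulR 2; SMulL 1; SRelabel 4 4 [1;2;3;0]; SMulL 5;
     SRelabel 6 5 [1;2;3;4;0]; SMulL 2; SRelabel 8 5 [1;2;3;4;0];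
     SRelabel 9 5 [0;1;3;2;4]; STrans 7 10; SMulL 0; SRelabel 12 3 [1;2;0]; SMulL 13;
     SRelabel 14 4 [1;2;3;0]; SMulL 15; SRelabel 16 5 [1;2;3;4;0];
     SRelabel 17 5 [1;0;2;3;4]; STrans 3 18; SRelabel 19 5 [0;3;1;2;4]; STrans 11 20;
     SRelabel 21 5 [1;0;2;3;4]; STrans 3 22]);
  ([3;1;2;0;4], Comm,
    [SRelabel 0 4 [0;1;1;2;3]; SContr 1 1 1 1; SRelabel 2 3 [0;0;1;2]; SMulR 3;
     SRelabel 4 3 [0;1;2;2]; SContr 5 2 2 2; SRelabel 6 2 [0;1;0]],
    [SMulR 0; SMulR 1; SMulR 2; SMulL 2; SRelabel 4 5 [1;2;3;4;0]; SMulL 1;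
     SRelabel 6 4 [1;2;3;0]; SMulL 7; SRelabel 8 5 [1;2;3;4;0];
     SRelabel 9 5 [0;2;1;3;4]; STrans 5 10; SRelabel 3 5 [0;2;1;3;4]; STrans 5 12;
     SRelabel 13 5 [0;2;3;1;4]; STrans 11 14; SRelabel 15 5 [1;0;2;3;4]; STrans 3 16]);
  ([3;1;2;4;0], Comm,
    [SRelabel 0 4 [0;1;1;2;3]; SContr 1 1 1 1; SRelabel 2 3 [0;0;1;2]; SMulR 3;
     SRelabel 4 3 [0;1;2;2]; SRelabel 3 3 [2;0;2]; SMulL 6; SRelabel 7 3 [0;1;2;1];
     STrans 5 8; SContr 9 2 2 2; SRelabel 10 2 [0;1;0]],
    [SMulR 0; SMulR 1; SMulR 2; SMulL 2; SRelabel 4 5 [1;2;3;4;0];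
     SRelabel 5 5 [1;0;2;3;4]; STrans 3 6; SMulL 1; SRelabel 8 4 [1;2;3;0]; SMulL 9;
     SRelabel 10 5 [1;2;3;4;0]; SRelabel 5 5 [0;1;3;2;4]; STrans 11 12; SMulL 0;
     SRelabel 14 3 [1;2;0]; SMulL 15; SRelabel 16 4 [1;2;3;0]; SMulL 17;
     SRelabel 18 5 [1;2;3;4;0]; SRelabel 19 5 [1;0;2;3;4]; STrans 3 20;
     SRelabel 21 5 [0;3;1;2;4]; STrans 13 22; SRelabel 23 5 [1;2;0;3;4]; STrans 7 24]);
  ([3;1;4;0;2], Comm,
    [SStar 0; SRelabel 1 5 [4;3;2;1;0]; SRelabel 0 5 [2;4;0;3;1]; STrans 2 3;
     SRelabel 4 4 [0;1;2;3;3]; SContr 5 3 3 0; SRelabel 6 3 [0;1;2;0]; SMulR 7;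
     SRelabel 8 3 [0;1;2;2]; SRelabel 7 3 [2;0;2]; SMulL 10; SRelabel 11 3 [0;1;2;1];
     STrans 9 12; SContr 13 2 2 2; SRelabel 14 2 [0;1;0]],
    [SMulR 0; SMulR 1; SMulR 2; SMulL 1; SRelabel 4 4 [1;2;3;0]; SMulL 5;
     SRelabel 6 5 [1;2;3;4;0]; SRelabel 7 5 [1;0;2;3;4]; STrans 3 8; SMulL 2;
     SRelabel 10 5 [1;2;3;4;0]; SRelabel 3 5 [0;2;1;3;4]; STrans 11 12; SMulL 0;
     SRelabel 14 3 [1;2;0]; SMulL 15; SRelabel 16 4 [1;2;3;0]; SMulL 17;
     SRelabel 18 5 [1;2;3;4;0]; SRelabel 7 5 [0;1;2;4;3]; STrans 19 20;
     SRelabel 21 5 [2;0;1;3;4]; STrans 13 22; SRelabel 23 5 [1;0;3;2;4]; STrans 9 24]);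
  ([3;1;4;2;0], Comm,
    [SRelabel 0 5 [3;1;4;2;0]; STrans 0 1; SRelabel 2 4 [0;1;1;2;3]; SContr 3 1 1 0;
     SRelabel 4 3 [0;0;1;2]; SMulL 5; SRelabel 6 4 [1;2;3;0]; SRelabel 7 3 [0;0;1;2];
     SContr 8 0 0 0; SRelabel 9 2 [0;0;1]],
    [SMulR 0; SMulR 1; SMulR 2; SMulL 2; SRelabel 4 5 [1;2;3;4;0]; SMulL 1;
     SRelabel 6 4 [1;2;3;0]; SMulL 7; SRelabel 8 5 [1;2;3;4;0];
     SRelabel 9 5 [0;2;1;3;4]; STrans 5 10; SRelabel 11 5 [1;0;2;3;4]; STrans 3 12;
     SRelabel 3 5 [0;2;1;3;4]; STrans 5 14; SMulL 0; SRelabel 16 3 [1;2;0]; SMulL 17;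
     SRelabel 18 4 [1;2;3;0]; SMulL 19; SRelabel 20 5 [1;2;3;4;0];
     SRelabel 9 5 [0;1;2;4;3]; STrans 21 22; SRelabel 23 5 [2;0;1;3;4]; STrans 15 24;
     SRelabel 25 5 [1;2;3;0;4]; STrans 13 26]);
  ([3;2;0;1;4], Comm,
    [SRelabel 0 4 [0;0;1;2;3]; SContr 1 0 0 2; SRelabel 2 3 [0;0;1;2]; SMulR 3;
     SRelabel 4 3 [0;1;2;2]; SContr 5 2 2 2; SRelabel 6 2 [0;1;0]],
    [SMulR 0; SMulR 1; SMulL 2; SRelabel 3 5 [1;2;3;4;0]; SMulR 2; SMulL 1;
     SRelabel 6 4 [1;2;3;0]; SMulL 7; SRelabel 8 5 [1;2;3;4;0];
     SRelabel 9 5 [1;0;2;3;4]; STrans 5 10; SRelabel 5 5 [0;2;1;3;4]; STrans 4 12;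
     SRelabel 13 5 [1;0;3;2;4]; STrans 11 14; SRelabel 15 5 [0;2;1;3;4]; STrans 4 16]);
  ([3;2;0;4;1], Comm,
    [SRelabel 0 4 [0;1;2;2;3]; SContr 1 2 2 0; SRelabel 2 3 [0;1;0;2]; SMulL 3;
     SRelabel 4 4 [1;2;3;0]; SRelabel 5 3 [0;0;1;2]; SContr 6 0 0 0;
     SRelabel 7 2 [0;0;1]],
    [SMulR 0; SMulR 1; SMulL 2; SRelabel 3 5 [1;2;3;4;0]; SMulR 2;
     SRelabel 5 5 [0;2;1;3;4]; STrans 4 6; SMulL 1; SRelabel 8 4 [1;2;3;0]; SMulL 9;
     SRelabel 10 5 [1;2;3;4;0]; SRelabel 4 5 [0;1;3;2;4]; STrans 11 12; SMulL 0;
     SRelabel 14 3 [1;2;0]; SMulL 15; SRelabel 16 4 [1;2;3;0]; SMulL 17;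
     SRelabel 18 5 [1;2;3;4;0]; SRelabel 19 5 [1;0;2;3;4]; STrans 5 20;
     SRelabel 21 5 [0;3;1;2;4]; STrans 13 22; SRelabel 23 5 [2;0;1;3;4]; STrans 7 24]);
  ([3;2;1;0;4], Comm,
    [SRelabel 0 4 [0;1;2;2;3]; SContr 1 2 2 0; SRelabel 2 3 [0;1;0;2]; SMulR 3;
     SRelabel 4 3 [0;1;2;2]; SContr 5 2 2 2; SRelabel 6 2 [0;1;0]],
    [SMulR 0; SMulR 1; SMulR 2; SMulL 2; SRelabel 4 5 [1;2;3;4;0];
     SRelabel 5 5 [1;0;2;3;4]; STrans 3 6; SMulL 1; SRelabel 8 4 [1;2;3;0]; SMulL 9;
     SRelabel 10 5 [1;2;3;4;0]; SRelabel 11 5 [1;0;2;3;4]; STrans 3 12;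
     SRelabel 3 5 [0;2;1;3;4]; STrans 5 14; SRelabel 15 5 [1;0;3;2;4]; STrans 13 16;
     SRelabel 17 5 [1;2;0;3;4]; STrans 7 18]);
  ([3;2;1;4;0], Comm,
    [SRelabel 0 4 [0;1;2;2;3]; SContr 1 2 2 0; SRelabel 2 3 [0;1;0;2]; SMulR 3;
     SRelabel 4 3 [0;1;2;2]; SRelabel 3 3 [2;0;2]; SMulL 6; SRelabel 7 3 [0;1;2;1];
     STrans 5 8; SContr 9 2 2 2; SRelabel 10 2 [0;1;0]],
    [SMulR 0; SMulR 1; SMulR 2; SMulL 2; SRelabel 4 5 [1;2;3;4;0];
     SRelabel 3 5 [0;2;1;3;4]; STrans 5 6; SRelabel 7 5 [1;0;2;3;4]; STrans 3 8;
     SMulL 1; SRelabel 10 4 [1;2;3;0]; SMulL 11; SRelabel 12 5 [1;2;3;4;0];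
     SRelabel 5 5 [0;1;3;2;4]; STrans 13 14; SMulL 0; SRelabel 16 3 [1;2;0]; SMulL 17;
     SRelabel 18 4 [1;2;3;0]; SMulL 19; SRelabel 20 5 [1;2;3;4;0];
     SRelabel 21 5 [1;0;2;3;4]; STrans 3 22; SRelabel 23 5 [0;3;1;2;4]; STrans 15 24;
     SRelabel 25 5 [2;1;0;3;4]; STrans 9 26]);
  ([3;2;4;0;1], Comm,
    [SRelabel 0 4 [0;0;1;2;3]; SContr 1 0 0 3; SRelabel 2 3 [0;0;1;2]; SMulR 3;
     SRelabel 4 3 [0;1;2;2]; SContr 5 2 2 2; SRelabel 6 2 [0;1;0]],
    [SMulR 0; SMulR 1; SMulL 2; SRelabel 3 5 [1;2;3;4;0]; SMulR 2; SMulL 1;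
     SRelabel 6 4 [1;2;3;0]; SMulL 7; SRelabel 8 5 [1;2;3;4;0];
     SRelabel 9 5 [1;0;2;3;4]; STrans 5 10; SRelabel 11 5 [0;2;1;3;4]; STrans 4 12;
     SRelabel 5 5 [0;2;1;3;4]; STrans 4 14; SMulL 0; SRelabel 16 3 [1;2;0]; SMulL 17;
     SRelabel 18 4 [1;2;3;0]; SMulL 19; SRelabel 20 5 [1;2;3;4;0];
     SRelabel 9 5 [0;1;2;4;3]; STrans 21 22; SRelabel 23 5 [2;0;1;3;4]; STrans 15 24;
     SRelabel 25 5 [2;0;3;1;4]; STrans 13 26]);
  ([3;2;4;1;0], Comm,
    [SRelabel 0 4 [0;0;1;2;3]; SContr 1 0 0 3; SRelabel 2 3 [0;0;1;2]; SMulR 3;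
     SRelabel 4 3 [0;1;2;2]; SContr 5 2 2 2; SRelabel 6 2 [0;1;0]],
    [SMulR 0; SMulR 1; SMulR 2; SMulL 2; SRelabel 4 5 [1;2;3;4;0];
     SRelabel 5 5 [1;0;2;3;4]; STrans 3 6; SMulL 1; SRelabel 8 4 [1;2;3;0]; SMulL 9;
     SRelabel 10 5 [1;2;3;4;0]; SRelabel 11 5 [1;0;2;3;4]; STrans 3 12;
     SRelabel 13 5 [1;2;0;3;4]; STrans 7 14; SRelabel 3 5 [0;2;1;3;4]; STrans 5 16;
     SMulL 0; SRelabel 18 3 [1;2;0]; SMulL 19; SRelabel 20 4 [1;2;3;0]; SMulL 21;
     SRelabel 22 5 [1;2;3;4;0]; SRelabel 11 5 [0;1;2;4;3]; STrans 23 24;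
     SRelabel 25 5 [2;0;1;3;4]; STrans 17 26; SRelabel 27 5 [2;1;3;0;4]; STrans 15 28]);
  ([3;4;0;1;2], Comm,
    [SRelabel 0 4 [0;0;1;2;3]; SContr 1 0 0 2; SRelabel 2 3 [0;0;1;2]; SMulR 3;
     SRelabel 4 3 [0;1;2;2]; SRelabel 3 3 [2;0;2]; SMulL 6; SRelabel 7 3 [0;1;2;1];
     STrans 5 8; SContr 9 2 2 2; SRelabel 10 2 [0;1;0]],
    [SMulR 0; SMulL 1; SRelabel 2 4 [1;2;3;0]; SMulL 3; SRelabel 4 5 [1;2;3;4;0]; SMulR 1;
     SMulL 6; SRelabel 7 5 [1;2;3;4;0]; SRelabel 8 5 [0;1;3;2;4]; STrans 5 9; SMulR 6;
     SMulL 0; SRelabel 12 3 [1;2;0]; SMulL 13; SRelabel 14 4 [1;2;3;0]; SMulL 15;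
     SRelabel 16 5 [1;2;3;4;0]; SRelabel 17 5 [1;0;2;3;4]; STrans 11 18;
     SRelabel 10 5 [1;0;2;4;3]; STrans 19 20; SRelabel 21 5 [0;3;1;2;4]; STrans 10 22]);
  ([3;4;0;2;1], Comm,
    [SRelabel 0 4 [0;1;2;3;3]; SContr 1 3 3 0; SRelabel 2 3 [0;1;2;0]; SMulL 3;
     SRelabel 4 4 [1;2;3;0]; SRelabel 5 3 [0;0;1;2]; SContr 6 0 0 0;
     SRelabel 7 2 [0;0;1]],
    [SMulR 0; SMulR 1; SMulL 2; SRelabel 3 5 [1;2;3;4;0]; SMulL 1; SRelabel 5 4 [1;2;3;0];
     SMulL 6; SRelabel 7 5 [1;2;3;4;0]; SRelabel 4 5 [0;1;3;2;4]; STrans 8 9;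
     SRelabel 10 5 [0;2;1;3;4]; STrans 4 11; SMulR 2; SMulL 0; SRelabel 14 3 [1;2;0];
     SMulL 15; SRelabel 16 4 [1;2;3;0]; SMulL 17; SRelabel 18 5 [1;2;3;4;0];
     SRelabel 19 5 [1;0;2;3;4]; STrans 13 20; SRelabel 10 5 [1;0;2;4;3]; STrans 21 22;
     SRelabel 23 5 [0;3;2;1;4]; STrans 12 24]);
  ([3;4;1;0;2], Comm,
    [SRelabel 0 4 [0;1;2;3;3]; SContr 1 3 3 0; SRelabel 2 3 [0;1;2;0]; SMulR 3;
     SRelabel 4 3 [0;1;2;2]; SContr 5 2 2 2; SRelabel 6 2 [0;1;0]],
    [SMulR 0; SMulR 1; SMulR 2; SMulL 1; SRelabel 4 4 [1;2;3;0]; SMulL 5;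
     SRelabel 6 5 [1;2;3;4;0]; SMulL 2; SRelabel 8 5 [1;2;3;4;0];
     SRelabel 9 5 [0;1;3;2;4]; STrans 7 10; SRelabel 11 5 [1;0;2;3;4]; STrans 3 12;
     SMulL 0; SRelabel 14 3 [1;2;0]; SMulL 15; SRelabel 16 4 [1;2;3;0]; SMulL 17;
     SRelabel 18 5 [1;2;3;4;0]; SRelabel 19 5 [1;0;2;3;4]; STrans 3 20;
     SRelabel 11 5 [1;0;2;4;3]; STrans 21 22; SRelabel 23 5 [1;3;0;2;4]; STrans 13 24]);
  ([3;4;1;2;0], Comm,
    [SRelabel 0 4 [0;1;2;3;3]; SContr 1 3 3 0; SRelabel 2 3 [0;1;2;0]; SMulR 3;
     SRelabel 4 3 [0;1;2;2]; SRelabel 3 3 [2;0;2]; SMulL 6; SRelabel 7 3 [0;1;2;1];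
     STrans 5 8; SContr 9 2 2 2; SRelabel 10 2 [0;1;0]],
    [SMulR 0; SMulR 1; SMulR 2; SMulL 2; SRelabel 4 5 [1;2;3;4;0];
     SRelabel 5 5 [1;0;2;3;4]; STrans 3 6; SMulL 1; SRelabel 8 4 [1;2;3;0]; SMulL 9;
     SRelabel 10 5 [1;2;3;4;0]; SRelabel 5 5 [0;1;3;2;4]; STrans 11 12;
     SRelabel 13 5 [1;2;0;3;4]; STrans 7 14; SMulL 0; SRelabel 16 3 [1;2;0]; SMulL 17;
     SRelabel 18 4 [1;2;3;0]; SMulL 19; SRelabel 20 5 [1;2;3;4;0];
     SRelabel 21 5 [1;0;2;3;4]; STrans 3 22; SRelabel 13 5 [1;0;2;4;3]; STrans 23 24;
     SRelabel 25 5 [1;3;2;0;4]; STrans 15 26]);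
  ([3;4;2;0;1], Comm,
    [SRelabel 0 4 [0;0;1;2;3]; SContr 1 0 0 3; SRelabel 2 3 [0;0;1;2]; SMulR 3;
     SRelabel 4 3 [0;1;2;2]; SRelabel 3 3 [2;0;2]; SMulL 6; SRelabel 7 3 [0;1;2;1];
     STrans 5 8; SContr 9 2 2 2; SRelabel 10 2 [0;1;0]],
    [SMulR 0; SMulR 1; SMulL 2; SRelabel 3 5 [1;2;3;4;0]; SMulR 2;
     SRelabel 5 5 [0;2;1;3;4]; STrans 4 6; SMulL 1; SRelabel 8 4 [1;2;3;0]; SMulL 9;
     SRelabel 10 5 [1;2;3;4;0]; SRelabel 4 5 [0;1;3;2;4]; STrans 11 12;
     SRelabel 13 5 [2;0;1;3;4]; STrans 7 14; SMulL 0; SRelabel 16 3 [1;2;0]; SMulL 17;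
     SRelabel 18 4 [1;2;3;0]; SMulL 19; SRelabel 20 5 [1;2;3;4;0];
     SRelabel 21 5 [1;0;2;3;4]; STrans 5 22; SRelabel 13 5 [1;0;2;4;3]; STrans 23 24;
     SRelabel 25 5 [2;3;0;1;4]; STrans 15 26]);
  ([3;4;2;1;0], Comm,
    [SRelabel 0 4 [0;1;1;2;3]; SContr 1 1 1 2; SRelabel 2 3 [0;0;1;2]; SMulR 3;
     SRelabel 4 3 [0;1;2;2]; SRelabel 3 3 [2;0;2]; SMulL 6; SRelabel 7 3 [0;1;2;1];
     STrans 5 8; SContr 9 2 2 2; SRelabel 10 2 [0;1;0]],
    [SMulR 0; SMulR 1; SMulR 2; SMulL 2; SRelabel 4 5 [1;2;3;4;0];
     SRelabel 3 5 [0;2;1;3;4]; STrans 5 6; SMulL 1; SRelabel 8 4 [1;2;3;0]; SMulL 9;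
     SRelabel 10 5 [1;2;3;4;0]; SRelabel 5 5 [0;1;3;2;4]; STrans 11 12;
     SRelabel 13 5 [2;0;1;3;4]; STrans 7 14; SMulL 0; SRelabel 16 3 [1;2;0]; SMulL 17;
     SRelabel 18 4 [1;2;3;0]; SMulL 19; SRelabel 20 5 [1;2;3;4;0];
     SRelabel 21 5 [1;0;2;3;4]; STrans 3 22; SRelabel 13 5 [1;0;2;4;3]; STrans 23 24;
     SRelabel 25 5 [2;3;0;1;4]; STrans 15 26; SRelabel 27 5 [1;0;2;3;4]; STrans 3 28]);
  ([4;0;1;2;3], Comm,
    [SStar 0; SRelabel 1 5 [4;3;2;1;0]; SRelabel 2 4 [0;1;1;2;3]; SContr 3 1 1 0;
     SRelabel 4 3 [0;0;1;2]; SMulR 5; SRelabel 6 3 [0;1;2;2]; SRelabel 5 3 [2;0;2];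
     SMulL 8; SRelabel 9 3 [0;1;2;1]; STrans 7 10; SContr 11 2 2 2;
     SRelabel 12 2 [0;1;0]],
    [SMulL 0; SRelabel 1 3 [1;2;0]; SMulL 2; SRelabel 3 4 [1;2;3;0]; SMulL 4;
     SRelabel 5 5 [1;2;3;4;0]; SMulR 0; SMulL 7; SRelabel 8 4 [1;2;3;0]; SMulL 9;
     SRelabel 10 5 [1;2;3;4;0]; SRelabel 11 5 [0;1;2;4;3]; STrans 6 12; SMulR 7;
     SMulL 14; SRelabel 15 5 [1;2;3;4;0]; SMulR 14; SRelabel 17 5 [0;2;1;3;4];
     STrans 16 18; SRelabel 19 5 [0;1;4;2;3]; STrans 13 20]);
  ([4;0;1;3;2], Comm,
    [SRelabel 0 4 [0;0;1;2;3]; SContr 1 0 0 1; SRelabel 2 3 [0;0;1;2];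
     SRelabel 0 4 [0;1;2;2;3]; SContr 4 2 2 3; SRelabel 5 3 [0;1;0;2];
     SRelabel 6 3 [2;1;0]; STrans 3 7; SMulL 8; SRelabel 9 4 [1;2;3;0];
     SRelabel 10 3 [0;0;1;2]; SContr 11 0 0 0; SRelabel 12 2 [0;0;1]],
    [SMulR 0; SMulL 1; SRelabel 2 4 [1;2;3;0]; SMulL 3; SRelabel 4 5 [1;2;3;4;0]; SMulL 0;
     SRelabel 6 3 [1;2;0]; SMulL 7; SRelabel 8 4 [1;2;3;0]; SMulL 9;
     SRelabel 10 5 [1;2;3;4;0]; SRelabel 5 5 [0;1;2;4;3]; STrans 11 12; SMulR 1;
     SMulL 14; SRelabel 15 5 [1;2;3;4;0]; SMulR 14; SRelabel 17 5 [0;2;1;3;4];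
     STrans 16 18; SRelabel 19 5 [0;1;4;2;3]; STrans 13 20; SRelabel 21 5 [0;1;3;2;4];
     STrans 5 22]);
  ([4;0;2;1;3], Comm,
    [SStar 0; SRelabel 1 5 [4;3;2;1;0]; SRelabel 2 4 [0;1;2;2;3]; SContr 3 2 2 1;
     SRelabel 4 3 [0;1;0;2]; SMulR 5; SRelabel 6 3 [0;1;2;2]; SRelabel 5 3 [2;0;2];
     SMulL 8; SRelabel 9 3 [0;1;2;1]; STrans 7 10; SContr 11 2 2 2;
     SRelabel 12 2 [0;1;0]],
    [SMulR 0; SMulR 1; SMulL 2; SRelabel 3 5 [1;2;3;4;0]; SMulL 0; SRelabel 5 3 [1;2;0];
     SMulL 6; SRelabel 7 4 [1;2;3;0]; SMulL 8; SRelabel 9 5 [1;2;3;4;0]; SMulL 1;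
     SRelabel 11 4 [1;2;3;0]; SMulL 12; SRelabel 13 5 [1;2;3;4;0];
     SRelabel 14 5 [0;1;2;4;3]; STrans 10 15; SMulR 2; SRelabel 17 5 [0;2;1;3;4];
     STrans 4 18; SRelabel 19 5 [0;1;4;2;3]; STrans 16 20; SRelabel 21 5 [0;2;1;3;4];
     STrans 4 22]);
  ([4;0;2;3;1], Comm,
    [SStar 0; SRelabel 1 5 [4;3;2;1;0]; SRelabel 2 4 [0;1;1;2;3]; SContr 3 1 1 1;
     SRelabel 4 3 [0;0;1;2]; SMulR 5; SRelabel 6 3 [0;1;2;2]; SRelabel 5 3 [2;0;2];
     SMulL 8; SRelabel 9 3 [0;1;2;1]; STrans 7 10; SContr 11 2 2 2;
     SRelabel 12 2 [0;1;0]],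
    [SMulR 0; SMulR 1; SMulL 2; SRelabel 3 5 [1;2;3;4;0]; SMulL 1; SRelabel 5 4 [1;2;3;0];
     SMulL 6; SRelabel 7 5 [1;2;3;4;0]; SRelabel 8 5 [0;2;1;3;4]; STrans 4 9; SMulL 0;
     SRelabel 11 3 [1;2;0]; SMulL 12; SRelabel 13 4 [1;2;3;0]; SMulL 14;
     SRelabel 15 5 [1;2;3;4;0]; SRelabel 8 5 [0;1;2;4;3]; STrans 16 17; SMulR 2;
     SRelabel 19 5 [0;2;1;3;4]; STrans 4 20; SRelabel 21 5 [0;1;4;2;3]; STrans 18 22;
     SRelabel 23 5 [0;2;3;1;4]; STrans 10 24]);
  ([4;0;3;1;2], Comm,
    [SRelabel 0 5 [4;0;3;1;2]; STrans 0 1; SRelabel 2 4 [0;0;1;2;3]; SContr 3 0 0 2;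
     SRelabel 4 3 [0;0;1;2]; SMulL 5; SRelabel 6 4 [1;2;3;0]; SRelabel 7 3 [0;0;1;2];
     SContr 8 0 0 0; SRelabel 9 2 [0;0;1]],
    [SMulR 0; SMulL 1; SRelabel 2 4 [1;2;3;0]; SMulL 3; SRelabel 4 5 [1;2;3;4;0]; SMulR 1;
     SMulL 6; SRelabel 7 5 [1;2;3;4;0]; SRelabel 8 5 [0;1;3;2;4]; STrans 5 9; SMulL 0;
     SRelabel 11 3 [1;2;0]; SMulL 12; SRelabel 13 4 [1;2;3;0]; SMulL 14;
     SRelabel 15 5 [1;2;3;4;0]; SRelabel 5 5 [0;1;2;4;3]; STrans 16 17; SMulR 6;
     SRelabel 19 5 [0;2;1;3;4]; STrans 8 20; SRelabel 21 5 [0;1;4;2;3]; STrans 18 22;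
     SRelabel 23 5 [0;3;1;2;4]; STrans 10 24]);
  ([4;0;3;2;1], Comm,
    [SStar 0; SRelabel 1 5 [4;3;2;1;0]; SRelabel 2 4 [0;1;2;2;3]; SContr 3 2 2 0;
     SRelabel 4 3 [0;1;0;2]; SMulR 5; SRelabel 6 3 [0;1;2;2]; SRelabel 5 3 [2;0;2];
     SMulL 8; SRelabel 9 3 [0;1;2;1]; STrans 7 10; SContr 11 2 2 2;
     SRelabel 12 2 [0;1;0]],
    [SMulR 0; SMulR 1; SMulL 2; SRelabel 3 5 [1;2;3;4;0]; SMulL 1; SRelabel 5 4 [1;2;3;0];
     SMulL 6; SRelabel 7 5 [1;2;3;4;0]; SRelabel 4 5 [0;1;3;2;4]; STrans 8 9;
     SRelabel 10 5 [0;2;1;3;4]; STrans 4 11; SMulL 0; SRelabel 13 3 [1;2;0]; SMulL 14;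
     SRelabel 15 4 [1;2;3;0]; SMulL 16; SRelabel 17 5 [1;2;3;4;0];
     SRelabel 8 5 [0;1;2;4;3]; STrans 18 19; SMulR 2; SRelabel 21 5 [0;2;1;3;4];
     STrans 4 22; SRelabel 23 5 [0;1;4;2;3]; STrans 20 24; SRelabel 25 5 [0;3;2;1;4];
     STrans 12 26]);
  ([4;1;0;2;3], Comm,
    [SRelabel 0 4 [0;0;1;2;3]; SContr 1 0 0 1; SRelabel 2 3 [0;0;1;2];
     SRelabel 0 4 [0;1;2;2;3]; SContr 4 2 2 3; SRelabel 5 3 [0;1;0;2];
     SRelabel 6 3 [2;0;1]; STrans 3 7; SMulR 8; SRelabel 9 3 [0;1;2;2];
     SContr 10 2 2 2; SRelabel 11 2 [0;1;0]],
    [SMulR 0; SMulR 1; SMulR 2; SMulL 0; SRelabel 4 3 [1;2;0]; SMulL 5;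
     SRelabel 6 4 [1;2;3;0]; SMulL 7; SRelabel 8 5 [1;2;3;4;0]; SMulL 1;
     SRelabel 10 4 [1;2;3;0]; SMulL 11; SRelabel 12 5 [1;2;3;4;0];
     SRelabel 13 5 [0;1;2;4;3]; STrans 9 14; SMulL 2; SRelabel 16 5 [1;2;3;4;0];
     SRelabel 3 5 [0;2;1;3;4]; STrans 17 18; SRelabel 19 5 [0;1;4;2;3]; STrans 15 20;
     SRelabel 21 5 [1;0;2;3;4]; STrans 3 22]);
  ([4;1;0;3;2], HalfComm,
    [SRelabel 0 4 [0;0;1;2;3]; SContr 1 0 0 1; SRelabel 2 3 [0;0;1;2]],
    [SMulL 0; SRelabel 1 4 [1;2;3;0]; SMulL 2; SRelabel 3 5 [1;2;3;4;0]; SMulR 0; SMulR 5;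
     SRelabel 6 5 [0;1;4;3;2]; STrans 4 7]);
  ([4;1;2;0;3], Comm,
    [SStar 0; SRelabel 1 5 [4;3;2;1;0]; SRelabel 2 4 [0;1;2;2;3]; SContr 3 2 2 2;
     SRelabel 4 3 [0;1;0;2]; SMulR 5; SRelabel 6 3 [0;1;2;2]; SRelabel 5 3 [2;0;2];
     SMulL 8; SRelabel 9 3 [0;1;2;1]; STrans 7 10; SContr 11 2 2 2;
     SRelabel 12 2 [0;1;0]],
    [SMulR 0; SMulR 1; SMulR 2; SMulL 2; SRelabel 4 5 [1;2;3;4;0];
     SRelabel 5 5 [1;0;2;3;4]; STrans 3 6; SMulL 0; SRelabel 8 3 [1;2;0]; SMulL 9;
     SRelabel 10 4 [1;2;3;0]; SMulL 11; SRelabel 12 5 [1;2;3;4;0]; SMulL 1;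
     SRelabel 14 4 [1;2;3;0]; SMulL 15; SRelabel 16 5 [1;2;3;4;0];
     SRelabel 17 5 [0;1;2;4;3]; STrans 13 18; SRelabel 3 5 [0;2;1;3;4]; STrans 5 20;
     SRelabel 21 5 [0;1;4;2;3]; STrans 19 22; SRelabel 23 5 [1;2;0;3;4]; STrans 7 24]);
  ([4;1;2;3;0], HalfComm,
    [SRelabel 0 4 [0;1;1;2;3]; SContr 1 1 1 1; SRelabel 2 3 [0;0;1;2]],
    [SMulR 0; SMulR 1; SMulL 0; SRelabel 3 4 [1;2;3;0]; SMulL 4; SRelabel 5 5 [1;2;3;4;0];
     SRelabel 2 5 [0;1;4;3;2]; STrans 6 7; SRelabel 8 5 [2;1;0;3;4]; STrans 2 9]);
  ([4;1;3;0;2], Comm,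
    [SRelabel 0 5 [4;1;3;0;2]; STrans 0 1; SRelabel 2 4 [0;1;1;2;3]; SContr 3 1 1 0;
     SRelabel 4 3 [0;0;1;2]; SMulL 5; SRelabel 6 4 [1;2;3;0]; SRelabel 7 3 [0;0;1;2];
     SContr 8 0 0 0; SRelabel 9 2 [0;0;1]],
    [SMulR 0; SMulR 1; SMulR 2; SMulL 1; SRelabel 4 4 [1;2;3;0]; SMulL 5;
     SRelabel 6 5 [1;2;3;4;0]; SMulL 2; SRelabel 8 5 [1;2;3;4;0];
     SRelabel 9 5 [0;1;3;2;4]; STrans 7 10; SRelabel 11 5 [1;0;2;3;4]; STrans 3 12;
     SMulL 0; SRelabel 14 3 [1;2;0]; SMulL 15; SRelabel 16 4 [1;2;3;0]; SMulL 17;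
     SRelabel 18 5 [1;2;3;4;0]; SRelabel 7 5 [0;1;2;4;3]; STrans 19 20;
     SRelabel 3 5 [0;2;1;3;4]; STrans 9 22; SRelabel 23 5 [0;1;4;2;3]; STrans 21 24;
     SRelabel 25 5 [1;3;0;2;4]; STrans 13 26]);
  ([4;1;3;2;0], Comm,
    [SRelabel 0 4 [0;1;2;2;3]; SContr 1 2 2 2; SRelabel 2 3 [0;1;0;2]; SMulR 3; SStar 0;
     SRelabel 5 5 [4;3;2;1;0]; SRelabel 6 5 [4;1;3;2;0]; STrans 0 7; SMulR 8;
     SRelabel 9 5 [0;1;2;3;4;4]; SContr 10 4 4 4; SRelabel 11 4 [0;1;2;3;0];
     SRelabel 12 4 [2;1;0;3]; STrans 4 13; SRelabel 14 3 [0;1;2;2]; SContr 15 2 2 0;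
     SRelabel 16 2 [0;1;0]],
    [SMulR 0; SMulR 1; SMulR 2; SMulL 2; SRelabel 4 5 [1;2;3;4;0];
     SRelabel 5 5 [1;0;2;3;4]; STrans 3 6; SMulL 1; SRelabel 8 4 [1;2;3;0]; SMulL 9;
     SRelabel 10 5 [1;2;3;4;0]; SRelabel 5 5 [0;1;3;2;4]; STrans 11 12;
     SRelabel 13 5 [1;2;0;3;4]; STrans 7 14; SMulL 0; SRelabel 16 3 [1;2;0]; SMulL 17;
     SRelabel 18 4 [1;2;3;0]; SMulL 19; SRelabel 20 5 [1;2;3;4;0];
     SRelabel 11 5 [0;1;2;4;3]; STrans 21 22; SRelabel 3 5 [0;2;1;3;4]; STrans 5 24;
     SRelabel 25 5 [0;1;4;2;3]; STrans 23 26; SRelabel 27 5 [1;3;2;0;4]; STrans 15 28]);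
  ([4;2;0;1;3], Comm,
    [SRelabel 0 5 [4;2;0;1;3]; STrans 0 1; SRelabel 2 4 [0;1;1;2;3]; SContr 3 1 1 3;
     SRelabel 4 3 [0;0;1;2]; SMulR 5; SRelabel 6 3 [0;1;2;2]; SContr 7 2 2 2;
     SRelabel 8 2 [0;1;0]],
    [SMulR 0; SMulR 1; SMulL 2; SRelabel 3 5 [1;2;3;4;0]; SMulR 2;
     SRelabel 5 5 [0;2;1;3;4]; STrans 4 6; SMulL 0; SRelabel 8 3 [1;2;0]; SMulL 9;
     SRelabel 10 4 [1;2;3;0]; SMulL 11; SRelabel 12 5 [1;2;3;4;0]; SMulL 1;
     SRelabel 14 4 [1;2;3;0]; SMulL 15; SRelabel 16 5 [1;2;3;4;0];
     SRelabel 17 5 [0;1;2;4;3]; STrans 13 18; SRelabel 7 5 [0;1;4;2;3]; STrans 19 20;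
     SRelabel 21 5 [2;0;1;3;4]; STrans 7 22]);
  ([4;2;0;3;1], Comm,
    [SRelabel 0 5 [4;2;0;3;1]; STrans 0 1; SRelabel 2 4 [0;1;2;3;3]; SContr 3 3 3 2;
     SRelabel 4 3 [0;1;2;0]; SMulR 5; SRelabel 6 3 [0;1;2;2]; SContr 7 2 2 2;
     SRelabel 8 2 [0;1;0]],
    [SMulR 0; SMulR 1; SMulL 2; SRelabel 3 5 [1;2;3;4;0]; SMulR 2; SMulL 1;
     SRelabel 6 4 [1;2;3;0]; SMulL 7; SRelabel 8 5 [1;2;3;4;0];
     SRelabel 9 5 [1;0;2;3;4]; STrans 5 10; SRelabel 11 5 [0;2;1;3;4]; STrans 4 12;
     SMulL 0; SRelabel 14 3 [1;2;0]; SMulL 15; SRelabel 16 4 [1;2;3;0]; SMulL 17;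
     SRelabel 18 5 [1;2;3;4;0]; SRelabel 9 5 [0;1;2;4;3]; STrans 19 20;
     SRelabel 5 5 [0;2;1;3;4]; STrans 4 22; SRelabel 23 5 [0;1;4;2;3]; STrans 21 24;
     SRelabel 25 5 [2;0;3;1;4]; STrans 13 26]);
  ([4;2;1;0;3], Comm,
    [SStar 0; SRelabel 1 5 [4;3;2;1;0]; SRelabel 2 4 [0;1;2;3;3]; SContr 3 3 3 1;
     SRelabel 4 3 [0;1;2;0]; SMulR 5; SRelabel 6 3 [0;1;2;2]; SRelabel 5 3 [2;0;2];
     SMulL 8; SRelabel 9 3 [0;1;2;1]; STrans 7 10; SContr 11 2 2 2;
     SRelabel 12 2 [0;1;0]],
    [SMulR 0; SMulR 1; SMulR 2; SMulL 2; SRelabel 4 5 [1;2;3;4;0];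
     SRelabel 3 5 [0;2;1;3;4]; STrans 5 6; SRelabel 7 5 [1;0;2;3;4]; STrans 3 8;
     SMulL 0; SRelabel 10 3 [1;2;0]; SMulL 11; SRelabel 12 4 [1;2;3;0]; SMulL 13;
     SRelabel 14 5 [1;2;3;4;0]; SMulL 1; SRelabel 16 4 [1;2;3;0]; SMulL 17;
     SRelabel 18 5 [1;2;3;4;0]; SRelabel 19 5 [0;1;2;4;3]; STrans 15 20;
     SRelabel 7 5 [0;1;4;2;3]; STrans 21 22; SRelabel 23 5 [2;1;0;3;4]; STrans 9 24]);
  ([4;2;1;3;0], Comm,
    [SRelabel 0 4 [0;1;1;2;3]; SContr 1 1 1 1; SRelabel 2 3 [0;0;1;2]; SMulR 3; SStar 0;
     SRelabel 5 5 [4;3;2;1;0]; SRelabel 6 5 [4;2;1;3;0]; STrans 0 7; SMulL 8;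
     SRelabel 9 6 [1;2;3;4;5;0]; SRelabel 10 5 [0;0;1;2;3;4]; SContr 11 0 0 0;
     SRelabel 12 4 [0;0;1;2;3]; SRelabel 13 4 [2;1;0;3]; STrans 4 14;
     SRelabel 15 3 [0;1;2;2]; SContr 16 2 2 2; SRelabel 17 2 [0;1;0]],
    [SMulR 0; SMulR 1; SMulR 2; SMulL 2; SRelabel 4 5 [1;2;3;4;0];
     SRelabel 5 5 [1;0;2;3;4]; STrans 3 6; SMulL 1; SRelabel 8 4 [1;2;3;0]; SMulL 9;
     SRelabel 10 5 [1;2;3;4;0]; SRelabel 11 5 [1;0;2;3;4]; STrans 3 12;
     SRelabel 13 5 [1;2;0;3;4]; STrans 7 14; SMulL 0; SRelabel 16 3 [1;2;0]; SMulL 17;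
     SRelabel 18 4 [1;2;3;0]; SMulL 19; SRelabel 20 5 [1;2;3;4;0];
     SRelabel 11 5 [0;1;2;4;3]; STrans 21 22; SRelabel 3 5 [0;2;1;3;4]; STrans 5 24;
     SRelabel 25 5 [0;1;4;2;3]; STrans 23 26; SRelabel 27 5 [2;1;3;0;4]; STrans 15 28]);
  ([4;2;3;0;1], Comm,
    [SStar 0; SRelabel 1 5 [4;3;2;1;0]; SRelabel 2 4 [0;1;2;3;3]; SContr 3 3 3 0;
     SRelabel 4 3 [0;1;2;0]; SMulR 5; SRelabel 6 3 [0;1;2;2]; SRelabel 5 3 [2;0;2];
     SMulL 8; SRelabel 9 3 [0;1;2;1]; STrans 7 10; SContr 11 2 2 2;
     SRelabel 12 2 [0;1;0]],
    [SMulR 0; SMulR 1; SMulL 2; SRelabel 3 5 [1;2;3;4;0]; SMulR 2;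
     SRelabel 5 5 [0;2;1;3;4]; STrans 4 6; SMulL 1; SRelabel 8 4 [1;2;3;0]; SMulL 9;
     SRelabel 10 5 [1;2;3;4;0]; SRelabel 4 5 [0;1;3;2;4]; STrans 11 12;
     SRelabel 13 5 [2;0;1;3;4]; STrans 7 14; SMulL 0; SRelabel 16 3 [1;2;0]; SMulL 17;
     SRelabel 18 4 [1;2;3;0]; SMulL 19; SRelabel 20 5 [1;2;3;4;0];
     SRelabel 11 5 [0;1;2;4;3]; STrans 21 22; SRelabel 7 5 [0;1;4;2;3]; STrans 23 24;
     SRelabel 25 5 [2;3;0;1;4]; STrans 15 26]);
  ([4;2;3;1;0], Comm,
    [SRelabel 0 4 [0;1;2;2;3]; SContr 1 2 2 1; SRelabel 2 3 [0;1;0;2];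
     SRelabel 0 4 [0;0;1;2;3]; SContr 4 0 0 3; SRelabel 5 3 [0;0;1;2];
     SRelabel 6 3 [2;1;0]; STrans 3 7; SMulL 8; SRelabel 9 4 [1;2;3;0];
     SRelabel 10 3 [0;0;1;2]; SContr 11 0 0 0; SRelabel 12 2 [0;0;1]],
    [SMulR 0; SMulR 1; SMulR 2; SMulL 2; SRelabel 4 5 [1;2;3;4;0];
     SRelabel 3 5 [0;2;1;3;4]; STrans 5 6; SMulL 1; SRelabel 8 4 [1;2;3;0]; SMulL 9;
     SRelabel 10 5 [1;2;3;4;0]; SRelabel 5 5 [0;1;3;2;4]; STrans 11 12;
     SRelabel 13 5 [2;0;1;3;4]; STrans 7 14; SMulL 0; SRelabel 16 3 [1;2;0]; SMulL 17;
     SRelabel 18 4 [1;2;3;0]; SMulL 19; SRelabel 20 5 [1;2;3;4;0];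
     SRelabel 11 5 [0;1;2;4;3]; STrans 21 22; SRelabel 7 5 [0;1;4;2;3]; STrans 23 24;
     SRelabel 25 5 [2;3;0;1;4]; STrans 15 26; SRelabel 27 5 [1;0;2;3;4]; STrans 3 28]);
  ([4;3;0;1;2], HalfComm,
    [SRelabel 0 4 [0;0;1;2;3]; SContr 1 0 0 2; SRelabel 2 3 [0;0;1;2]],
    [SMulR 0; SMulL 1; SRelabel 2 5 [1;2;3;4;0]; SMulL 0; SRelabel 4 4 [1;2;3;0]; SMulL 5;
     SRelabel 6 5 [1;2;3;4;0]; SMulR 1; SRelabel 8 5 [0;1;4;3;2]; STrans 7 9;
     SRelabel 10 5 [0;3;2;1;4]; STrans 3 11]);
  ([4;3;0;2;1], Comm,
    [SRelabel 0 4 [0;1;2;3;3]; SContr 1 3 3 0; SRelabel 2 3 [0;1;2;0]; SMulL 3;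
     SRelabel 4 4 [1;2;3;0]; SRelabel 5 3 [0;0;1;2]; SContr 6 0 0 0;
     SRelabel 7 2 [0;0;1]],
    [SMulR 0; SMulR 1; SMulL 2; SRelabel 3 5 [1;2;3;4;0]; SMulL 1; SRelabel 5 4 [1;2;3;0];
     SMulL 6; SRelabel 7 5 [1;2;3;4;0]; SRelabel 8 5 [0;2;1;3;4]; STrans 4 9; SMulR 2;
     SRelabel 11 5 [0;2;1;3;4]; STrans 4 12; SRelabel 13 5 [0;2;3;1;4]; STrans 10 14;
     SMulL 0; SRelabel 16 3 [1;2;0]; SMulL 17; SRelabel 18 4 [1;2;3;0]; SMulL 19;
     SRelabel 20 5 [1;2;3;4;0]; SRelabel 8 5 [0;1;2;4;3]; STrans 21 22;
     SRelabel 13 5 [0;1;4;2;3]; STrans 23 24; SRelabel 25 5 [3;0;2;1;4]; STrans 15 26]);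
  ([4;3;1;0;2], Comm,
    [SRelabel 0 4 [0;1;2;3;3]; SContr 1 3 3 0; SRelabel 2 3 [0;1;2;0]; SMulR 3;
     SRelabel 4 3 [0;1;2;2]; SContr 5 2 2 2; SRelabel 6 2 [0;1;0]],
    [SMulR 0; SMulR 1; SMulR 2; SMulL 1; SRelabel 4 4 [1;2;3;0]; SMulL 5;
     SRelabel 6 5 [1;2;3;4;0]; SRelabel 7 5 [1;0;2;3;4]; STrans 3 8; SMulL 2;
     SRelabel 10 5 [1;2;3;4;0]; SRelabel 3 5 [0;2;1;3;4]; STrans 11 12;
     SRelabel 13 5 [1;0;3;2;4]; STrans 9 14; SMulL 0; SRelabel 16 3 [1;2;0]; SMulL 17;
     SRelabel 18 4 [1;2;3;0]; SMulL 19; SRelabel 20 5 [1;2;3;4;0];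
     SRelabel 7 5 [0;1;2;4;3]; STrans 21 22; SRelabel 13 5 [0;1;4;2;3]; STrans 23 24;
     SRelabel 25 5 [3;1;0;2;4]; STrans 15 26]);
  ([4;3;1;2;0], Comm,
    [SRelabel 0 4 [0;1;2;3;3]; SContr 1 3 3 0; SRelabel 2 3 [0;1;2;0]; SMulR 3;
     SRelabel 4 3 [0;1;2;2]; SRelabel 3 3 [2;0;2]; SMulL 6; SRelabel 7 3 [0;1;2;1];
     STrans 5 8; SContr 9 2 2 2; SRelabel 10 2 [0;1;0]],
    [SMulR 0; SMulR 1; SMulR 2; SMulL 2; SRelabel 4 5 [1;2;3;4;0]; SMulL 1;
     SRelabel 6 4 [1;2;3;0]; SMulL 7; SRelabel 8 5 [1;2;3;4;0];
     SRelabel 9 5 [0;2;1;3;4]; STrans 5 10; SRelabel 3 5 [0;2;1;3;4]; STrans 5 12;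
     SRelabel 13 5 [0;2;3;1;4]; STrans 11 14; SMulL 0; SRelabel 16 3 [1;2;0]; SMulL 17;
     SRelabel 18 4 [1;2;3;0]; SMulL 19; SRelabel 20 5 [1;2;3;4;0];
     SRelabel 9 5 [0;1;2;4;3]; STrans 21 22; SRelabel 13 5 [0;1;4;2;3]; STrans 23 24;
     SRelabel 25 5 [3;0;2;1;4]; STrans 15 26; SRelabel 27 5 [1;0;2;3;4]; STrans 3 28]);
  ([4;3;2;0;1], Comm,
    [SRelabel 0 4 [0;1;2;3;3]; SContr 1 3 3 0; SRelabel 2 3 [0;1;2;0];
     SRelabel 0 4 [0;0;1;2;3]; SContr 4 0 0 3; SRelabel 5 3 [0;0;1;2];
     SRelabel 6 3 [2;0;1]; STrans 3 7; SMulR 8; SRelabel 9 3 [0;1;2;2];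
     SContr 10 2 2 2; SRelabel 11 2 [0;1;0]],
    [SMulR 0; SMulR 1; SMulL 2; SRelabel 3 5 [1;2;3;4;0]; SMulR 2; SMulL 1;
     SRelabel 6 4 [1;2;3;0]; SMulL 7; SRelabel 8 5 [1;2;3;4;0];
     SRelabel 9 5 [1;0;2;3;4]; STrans 5 10; SRelabel 5 5 [0;2;1;3;4]; STrans 4 12;
     SRelabel 13 5 [1;0;3;2;4]; STrans 11 14; SMulL 0; SRelabel 16 3 [1;2;0]; SMulL 17;
     SRelabel 18 4 [1;2;3;0]; SMulL 19; SRelabel 20 5 [1;2;3;4;0];
     SRelabel 9 5 [0;1;2;4;3]; STrans 21 22; SRelabel 13 5 [0;1;4;2;3]; STrans 23 24;
     SRelabel 25 5 [3;1;0;2;4]; STrans 15 26; SRelabel 27 5 [0;2;1;3;4]; STrans 4 28]);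
  ([4;3;2;1;0], HalfComm,
    [SRelabel 0 4 [0;1;2;3;3]; SContr 1 3 3 0; SRelabel 2 3 [0;1;2;0]],
    [SMulR 0; SMulR 1; SMulL 1; SRelabel 3 5 [1;2;3;4;0]; SRelabel 4 5 [2;1;0;3;4];
     STrans 2 5; SMulL 0; SRelabel 7 4 [1;2;3;0]; SMulL 8; SRelabel 9 5 [1;2;3;4;0];
     SRelabel 2 5 [0;1;4;3;2]; STrans 10 11; SRelabel 12 5 [2;3;0;1;4]; STrans 6 13])].

Definition certified (p : list nat) : bool :=
  existsb (fun '(q, c, forward, backward) =>
      if list_nat_eqb q p
      then entails [perm_rel p] (kind_rel c) forward && entails [kind_rel c] (perm_rel p) backward
      else false)
    certificates.

Fixpoint words (m n : nat) : list (list nat) :=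
  match n with
  | 0 => [[]]
  | S n' => flat_map (fun a => map (cons a) (words m n')) (seq 0 m)
  end.

Fixpoint nodupb (w : list nat) : bool :=
  match w with [] => true | a :: w' => negb (existsb (Nat.eqb a) w') && nodupb w' end.

Definition certificates_complete : bool :=
  forallb (fun k => forallb (fun p =>
      if nodupb p then list_nat_eqb p (seq 0 k) || certified p else true) (words k k))
    [1; 2; 3; 4; 5].

Lemma comm_to_halfcomm_ok : entails [comm_rel] halfcomm_rel comm_to_halfcomm = true.
Proof. vm_compute. reflexivity. Qed.

Lemma certificates_complete_ok : certificates_complete = true.
Proof. vm_compute. reflexivity. Qed.

Lemma perm_list_length k (s : nat -> nat) : length (map s (seq 0 k)) = k.
Proof. rewrite length_map, length_seq. reflexivity. Qed.

Lemma nth_perm_list k (s : nat -> nat) r : r < k -> nth r (map s (seq 0 k)) 0 = s r.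
Proof.
  intro Hr. rewrite (nth_indep _ 0 (s 0)) by (rewrite perm_list_length; exact Hr).
  rewrite map_nth, seq_nth; auto.
Qed.

Lemma perm_list_NoDup k s : is_perm k s -> NoDup (map s (seq 0 k)).
Proof.
  intros [_ Hinj]. apply NoDup_map_NoDup_ForallPairs; [|apply seq_NoDup].
  intros a c Ha Hc. apply in_seq in Ha, Hc. apply Hinj; lia.
Qed.

Lemma nodupb_NoDup w : NoDup w -> nodupb w = true.
Proof.
  induction 1 as [|a w Ha _ IH]; simpl; [reflexivity|]. rewrite IH, andb_true_r.
  apply negb_true_iff, not_true_iff_false. intro Hex.
  apply existsb_exists in Hex as [c [Hc E]]. apply Nat.eqb_eq in E. subst. contradiction.
Qed.

Lemma in_words m w : (forall v, In v w -> v < m) -> In w (words m (length w)).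
Proof.
  induction w as [|a w IH]; intro Hw; simpl; [left; reflexivity|].
  apply in_flat_map. exists a. split.
  - apply in_seq. specialize (Hw a (or_introl eq_refl)). lia.
  - apply in_map, IH. intros; apply Hw; right; auto.
Qed.

Lemma holds_perm_rel_id N b A (x : nat -> car A) n : holds N b x (perm_rel (seq 0 n)).
Proof.
  assert (Hinv : inversion_pairs (seq 0 n) = []).
  { unfold inversion_pairs. rewrite length_seq, (filter_ext_in _ (fun _ => false)), filter_false;
      [reflexivity|].
    intros [a c] Hac. apply in_prod_iff in Hac as [Ha Hc]. apply in_seq in Ha, Hc. simpl.
    rewrite !seq_nth by lia. destruct (Nat.ltb_spec a c); [apply Nat.ltb_ge; lia | reflexivity]. }
  unfold perm_rel. rewrite Hinv, length_seq. apply holds_refl.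
Qed.

Definition has_kind (p : list nat) (c : kind) : Prop :=
  forall N b A (x : nat -> car A), sphere_pt N A x ->
    (holds N b x (perm_rel p) <-> holds N b x (kind_rel c)).

Lemma certified_has_kind p : certified p = true -> exists c, has_kind p c.
Proof.
  intro Hc. apply existsb_exists in Hc as [[[[q c] forward] backward] [_ Hc]].
  destruct (list_nat_eqb q p); [|discriminate]. apply andb_true_iff in Hc as [Hf Hb].
  exists c. intros N b A x Hx.
  split; intro H; eapply (entails_sound N b A x Hx [_]); eauto.
Qed.

Lemma perm_rel_kind k s : 1 <= k <= 5 -> is_perm k s ->
  map s (seq 0 k) = seq 0 k \/ exists c, has_kind (map s (seq 0 k)) c.
Proof.
  intros Hk Hs.
  assert (Hwords : In (map s (seq 0 k)) (words k k)).
  { rewrite <- (perm_list_length k s) at 3. apply in_words. intros v Hv.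
    apply in_map_iff in Hv as [r [<- Hr]]. apply in_seq in Hr. apply (proj1 Hs). lia. }
  pose proof certificates_complete_ok as Hall. unfold certificates_complete in Hall.
  rewrite forallb_forall in Hall. specialize (Hall k ltac:(simpl; lia)).
  rewrite forallb_forall in Hall. specialize (Hall _ Hwords).
  rewrite (nodupb_NoDup _ (perm_list_NoDup k s Hs)), orb_true_iff in Hall.
  destruct Hall as [Hid|Hcert]; [left; apply list_nat_eqb_eq, Hid | right; apply certified_has_kind, Hcert].
Qed.

Lemma holds_comm_halfcomm N b A (x : nat -> car A) :
  sphere_pt N A x -> holds N b x comm_rel -> holds N b x halfcomm_rel.
Proof. intros Hx H. eapply (entails_sound N b A x Hx [_]); eauto using comm_to_halfcomm_ok. Qed.

Lemma holds_comm_perm_rel N b A (x : nat -> car A) k s : 1 <= k <= 5 -> is_perm k s ->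
  sphere_pt N A x -> holds N b x comm_rel -> holds N b x (perm_rel (map s (seq 0 k))).
Proof.
  intros Hk Hs Hx H. destruct (perm_rel_kind k s Hk Hs) as [-> | [[|] Hc]].
  - apply holds_perm_rel_id.
  - apply (Hc N b A x Hx), H.
  - apply (Hc N b A x Hx), holds_comm_halfcomm; auto.
Qed.

Lemma R_sigma_iff N k s A (x : nat -> car A) :
  R_sigma N k s A x <-> holds N false x (perm_rel (map s (seq 0 k))).
Proof.
  unfold R_sigma, holds, perm_rel, indices_ok, word. simpl. rewrite perm_list_length.
  split; intros H i Hi; specialize (H i Hi); rewrite !map_map in *; exact H.
Qed.

Lemma filter_filter {T} (f g : T -> bool) l : filter f (filter g l) = filter (fun a => g a && f a) l.
Proof. induction l as [|a l IH]; simpl; [reflexivity|]. destruct (g a); simpl; rewrite ?IH; reflexivity. Qed.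

Lemma odd_inv_count k s i :
  Nat.odd (inv_count k s i) = parity (inversion_pairs (map s (seq 0 k))) i.
Proof.
  unfold parity, inversion_pairs, inv_count.
  rewrite perm_list_length, filter_map_swap, length_map, filter_filter.
  do 2 f_equal. apply filter_ext_in. intros [a c] Hac. apply in_prod_iff in Hac as [Ha Hc].
  apply in_seq in Ha, Hc. simpl. rewrite !nth_perm_list by lia. reflexivity.
Qed.

Lemma Rbar_sigma_iff N k s A (x : nat -> car A) :
  Rbar_sigma N k s A x <-> holds N true x (perm_rel (map s (seq 0 k))).
Proof.
  unfold Rbar_sigma, holds, perm_rel, indices_ok, word. simpl. rewrite perm_list_length.
  split; intros H i Hi; specialize (H i Hi); rewrite !map_map, ?odd_inv_count in *; exact H.
Qed.

Lemma classical_iff N A (x : nat -> car A) : classical N A x <-> holds N false x comm_rel.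
Proof.
  unfold classical, holds, word, mprod. simpl. split.
  - intros H i Hi. rewrite !mul1r. apply H; apply Hi; lia.
  - intros H a c Ha Hc. specialize (H (fun t => nth t [a; c] 0)). simpl in H.
    rewrite !mul1r in H. apply H. intros [|[|v]] Hv; simpl; lia.
Qed.

Lemma anticomm_iff N A (x : nat -> car A) : anticomm N A x <-> holds N true x comm_rel.
Proof.
  unfold anticomm, holds, word, mprod, parity, distinct_at. simpl. split.
  - intros H i Hi. rewrite !mul1r.
    destruct (Nat.eqb_spec (i 1) (i 0)) as [E|E]; simpl; [rewrite E; reflexivity|].
    apply H; try (apply Hi; lia). congruence.
  - intros H a c Ha Hc Hac. specialize (H (fun t => nth t [a; c] 0)). simpl in H.
    rewrite !mul1r in H. destruct (Nat.eqb_spec c a); [congruence|].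
    apply H. intros [|[|v]] Hv; simpl; lia.
Qed.

Lemma halflib_iff N A (x : nat -> car A) : halflib N A x <-> holds N false x halfcomm_rel.
Proof.
  unfold halflib, holds, word, mprod. simpl. split.
  - intros H i Hi. rewrite !mul1r. apply H; apply Hi; lia.
  - intros H a b c Ha Hb Hc. specialize (H (fun t => nth t [a; b; c] 0)). simpl in H.
    rewrite !mul1r in H. apply H. intros [|[|[|v]]] Hv; simpl; lia.
Qed.

(* Among three letters the number of distinct pairs is odd iff the letters are pairwise
   distinct. *)
Lemma all_distinct_parity a b c :
  negb (a =? b) && negb (b =? c) && negb (a =? c) =
  xorb (negb (c =? b)) (xorb (negb (c =? a)) (xorb (negb (b =? a)) false)).
Proof.
  destruct (Nat.eqb_spec a b), (Nat.eqb_spec b c), (Nat.eqb_spec a c),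
    (Nat.eqb_spec c b), (Nat.eqb_spec c a), (Nat.eqb_spec b a);
  simpl; try reflexivity; exfalso; lia.
Qed.

Lemma halflib_bar_iff N A (x : nat -> car A) : halflib_bar N A x <-> holds N true x halfcomm_rel.
Proof.
  unfold halflib_bar, holds, word, mprod, parity, distinct_at. simpl. split.
  - intros H i Hi. rewrite !mul1r, H by (apply Hi; lia). f_equal. rewrite all_distinct_parity.
    destruct (negb (i 2 =? i 1)), (negb (i 2 =? i 0)), (negb (i 1 =? i 0)); reflexivity.
  - intros H a b c Ha Hb Hc. specialize (H (fun t => nth t [a; b; c] 0)). simpl in H.
    rewrite !mul1r in H. rewrite H by (intros [|[|[|v]]] Hv; simpl; lia). f_equal.
    rewrite all_distinct_parity.
    destruct (negb (c =? b)), (negb (c =? a)), (negb (b =? a)); reflexivity.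
Qed.

Lemma sph_eq_trans N P Q R : sph_eq N P Q -> sph_eq N Q R -> sph_eq N P R.
Proof. intros H1 H2 A x Hx. rewrite (H1 A x Hx). apply H2, Hx. Qed.

Lemma sph_eq_and N P Q P' Q' :
  sph_eq N P P' -> sph_eq N Q Q' -> sph_eq N (rels_and P Q) (rels_and P' Q').
Proof. intros H1 H2 A x Hx. unfold rels_and. rewrite (H1 A x Hx), (H2 A x Hx). reflexivity. Qed.

Definition perm_rels (N : nat) (twisted : bool) (E : permset) : rels := fun A x =>
  forall k s, E k s -> holds N twisted x (perm_rel (map s (seq 0 k))).

Section PermRels.
Variables (N : nat) (twisted : bool) (E : permset).
Hypothesis HE : forall k s, E k s -> (1 <= k <= 5)%nat /\ is_perm k s.

Lemma perm_rels_kind c :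
  (exists k s, E k s /\ has_kind (map s (seq 0 k)) c) ->
  (forall k s, E k s -> forall A (x : nat -> car A), sphere_pt N A x ->
     holds N twisted x (kind_rel c) -> holds N twisted x (perm_rel (map s (seq 0 k)))) ->
  sph_eq N (perm_rels N twisted E) (fun A x => holds N twisted x (kind_rel c)).
Proof.
  intros [k0 [s0 [E0 Hc]]] Himp A x Hx. split.
  - intro H. apply (Hc N twisted A x Hx), H, E0.
  - intros H k s Eks. apply Himp; auto.
Qed.

Lemma perm_rels_classification :
  sph_eq N (perm_rels N twisted E) (fun A x => holds N twisted x comm_rel) \/
  sph_eq N (perm_rels N twisted E) (fun A x => holds N twisted x halfcomm_rel) \/
  sph_eq N (perm_rels N twisted E) free_rels.
Proof.
  destruct (classic (exists k s, E k s /\ has_kind (map s (seq 0 k)) Comm)) as [Hcomm|Hncomm].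
  { left. apply (perm_rels_kind Comm Hcomm). intros k s Eks A x Hx.
    destruct (HE k s Eks). apply holds_comm_perm_rel; auto. }
  assert (Hmember : forall k s, E k s -> forall A (x : nat -> car A), sphere_pt N A x ->
            holds N twisted x (perm_rel (map s (seq 0 k))) \/
            has_kind (map s (seq 0 k)) HalfComm).
  { intros k s Eks A x Hx. destruct (HE k s Eks) as [Hk Hs].
    destruct (perm_rel_kind k s Hk Hs) as [-> | [[|] Hc]].
    - left. apply holds_perm_rel_id.
    - exfalso. apply Hncomm. eauto.
    - right. exact Hc. }
  right. destruct (classic (exists k s, E k s /\ has_kind (map s (seq 0 k)) HalfComm))
    as [Hhalf|Hnhalf].
  - left. apply (perm_rels_kind HalfComm Hhalf). intros k s Eks A x Hx H.
    destruct (Hmember k s Eks A x Hx) as [|Hc]; [assumption | apply (Hc N twisted A x Hx), H].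
  - right. intros A x Hx. split; [constructor|]. intros _ k s Eks.
    destruct (Hmember k s Eks A x Hx) as [|Hc]; [assumption | exfalso; apply Hnhalf; eauto].
Qed.

End PermRels.

Lemma S_E_classification N E (HE : forall k s, E k s -> (1 <= k <= 5)%nat /\ is_perm k s) :
  sph_eq N (S_E N E) (classical N) \/ sph_eq N (S_E N E) (halflib N)
  \/ sph_eq N (S_E N E) free_rels.
Proof.
  assert (HS : forall A x, S_E N E A x <-> perm_rels N false E A x).
  { intros A x. split; intros H k s Eks; apply R_sigma_iff; auto. }
  destruct (perm_rels_classification N false E HE) as [H|[H|H]]; [left|right; left|right; right];
    intros A x Hx; rewrite HS, (H A x Hx);
    [symmetry; apply classical_iff | symmetry; apply halflib_iff | reflexivity].
Qed.

Lemma Sbar_F_classification N F (HF : forall k s, F k s -> (1 <= k <= 5)%nat /\ is_perm k s) :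
  sph_eq N (Sbar_F N F) (anticomm N) \/ sph_eq N (Sbar_F N F) (halflib_bar N)
  \/ sph_eq N (Sbar_F N F) free_rels.
Proof.
  assert (HS : forall A x, Sbar_F N F A x <-> perm_rels N true F A x).
  { intros A x. split; intros H k s Eks; apply Rbar_sigma_iff; auto. }
  destruct (perm_rels_classification N true F HF) as [H|[H|H]]; [left|right; left|right; right];
    intros A x Hx; rewrite HS, (H A x Hx);
    [symmetry; apply anticomm_iff | symmetry; apply halflib_bar_iff | reflexivity].
Qed.

Lemma S_E_single_classification N k s :
  (1 <= k <= 5)%nat -> is_perm k s -> (exists r, (r < k)%nat /\ s r <> r) ->
  sph_eq N (S_E N (single k s)) (classical N) \/ sph_eq N (S_E N (single k s)) (halflib N).
Proof.
  intros Hk Hs [r [Hr Hsr]].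
  assert (HS : forall A x, S_E N (single k s) A x <-> holds N false x (perm_rel (map s (seq 0 k)))).
  { intros A x. unfold S_E, single. rewrite <- R_sigma_iff. split.
    - intro H. apply H. auto.
    - intros H k' s' [-> ->]. exact H. }
  destruct (perm_rel_kind k s Hk Hs) as [Hid | [[|] Hc]].
  - exfalso. apply Hsr. rewrite <- (nth_perm_list k s r Hr), Hid, seq_nth; auto.
  - left. intros A x Hx. rewrite HS, (Hc N false A x Hx). symmetry; apply classical_iff.
  - right. intros A x Hx. rewrite HS, (Hc N false A x Hx). symmetry; apply halflib_iff.
Qed.

Section MixedRelations.
Variables (N : nat) (A : CStarAlg) (x : nat -> car A).

Lemma classical_anticomm_poly0 : classical N A x -> anticomm N A x -> poly0 N A x.
Proof.
  intros Hc Ha i j Hi Hj Hij. apply (eq_and_eq_oppr_eq0 A _ (cmul (x j) (x i))); auto.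
Qed.

Lemma poly0_anticomm : poly0 N A x -> anticomm N A x.
Proof. intros H0 i j Hi Hj Hij. rewrite (H0 i j), (H0 j i) by auto. symmetry; apply oppr0. Qed.

Lemma all_distinct_true i j k :
  negb (i =? j) && negb (j =? k) && negb (i =? k) = true <-> i <> j /\ j <> k /\ i <> k.
Proof.
  rewrite !andb_true_iff, !negb_true_iff, !Nat.eqb_neq. tauto.
Qed.

Lemma halflib_halflib_bar_poly1 : halflib N A x -> halflib_bar N A x -> poly1 N A x.
Proof.
  intros Hh Hb i j k Hi Hj Hk Hij Hjk Hik. specialize (Hb i j k Hi Hj Hk).
  rewrite (proj2 (all_distinct_true i j k)) in Hb by auto.
  exact (eq_and_eq_oppr_eq0 A _ _ (Hh i j k Hi Hj Hk) Hb).
Qed.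

Lemma halflib_poly1_halflib_bar : halflib N A x -> poly1 N A x -> halflib_bar N A x.
Proof.
  intros Hh H0 i j k Hi Hj Hk.
  destruct (negb (i =? j) && negb (j =? k) && negb (i =? k)) eqn:Hd; [|apply Hh; auto].
  apply all_distinct_true in Hd as (? & ? & ?).
  rewrite (H0 i j k), (H0 k j i) by auto. symmetry; apply oppr0.
Qed.

Lemma halflib_bar_poly1_halflib : halflib_bar N A x -> poly1 N A x -> halflib N A x.
Proof.
  intros Hb H0 i j k Hi Hj Hk. specialize (Hb i j k Hi Hj Hk).
  destruct (negb (i =? j) && negb (j =? k) && negb (i =? k)) eqn:Hd; [|exact Hb].
  apply all_distinct_true in Hd as (? & ? & ?).
  rewrite (H0 i j k), (H0 k j i) by auto. reflexivity.
Qed.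

Hypothesis sphere : sphere_pt N A x.

Lemma classical_halflib : classical N A x -> halflib N A x.
Proof. intro H. apply halflib_iff, holds_comm_halfcomm, classical_iff; auto. Qed.

Lemma anticomm_halflib_bar : anticomm N A x -> halflib_bar N A x.
Proof. intro H. apply halflib_bar_iff, holds_comm_halfcomm, anticomm_iff; auto. Qed.

End MixedRelations.

Lemma free_and N Q : sph_eq N (rels_and free_rels Q) Q.
Proof. intros A x _. unfold rels_and, free_rels. tauto. Qed.

Lemma and_free N P : sph_eq N (rels_and P free_rels) P.
Proof. intros A x _. unfold rels_and, free_rels. tauto. Qed.

Lemma classical_and_anticomm N :
  sph_eq N (rels_and (classical N) (anticomm N)) (rels_and (classical N) (poly0 N)).
Proof.
  intros A x Hx. unfold rels_and. split; intros [Hc H]; split; auto.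
  - apply classical_anticomm_poly0; auto.
  - apply poly0_anticomm; auto.
Qed.

Lemma classical_and_halflib_bar N :
  sph_eq N (rels_and (classical N) (halflib_bar N)) (rels_and (classical N) (poly1 N)).
Proof.
  intros A x Hx. unfold rels_and. split; intros [Hc H]; split; auto.
  - apply halflib_halflib_bar_poly1; auto. apply classical_halflib; auto.
  - apply halflib_poly1_halflib_bar; auto. apply classical_halflib; auto.
Qed.

Lemma halflib_and_anticomm N :
  sph_eq N (rels_and (halflib N) (anticomm N)) (rels_and (anticomm N) (poly1 N)).
Proof.
  intros A x Hx. unfold rels_and. split; intros [H1 H2]; split; auto.
  - apply halflib_halflib_bar_poly1; auto. apply anticomm_halflib_bar; auto.
  - apply halflib_bar_poly1_halflib; auto. apply anticomm_halflib_bar; auto.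
Qed.

Lemma halflib_and_halflib_bar N :
  sph_eq N (rels_and (halflib N) (halflib_bar N)) (rels_and (halflib N) (poly1 N)).
Proof.
  intros A x Hx. unfold rels_and. split; intros [Hh H]; split; auto.
  - apply halflib_halflib_bar_poly1; auto.
  - apply halflib_poly1_halflib_bar; auto.
Qed.

Lemma mixed_classification N P Q :
  (sph_eq N P (classical N) \/ sph_eq N P (halflib N) \/ sph_eq N P free_rels) ->
  (sph_eq N Q (anticomm N) \/ sph_eq N Q (halflib_bar N) \/ sph_eq N Q free_rels) ->
  let M := rels_and P Q in
  sph_eq N M (classical N)
  \/ sph_eq N M (halflib N)
  \/ sph_eq N M free_rels
  \/ sph_eq N M (rels_and (classical N) (poly1 N))
  \/ sph_eq N M (rels_and (halflib N) (poly1 N))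
  \/ sph_eq N M (halflib_bar N)
  \/ sph_eq N M (rels_and (classical N) (poly0 N))
  \/ sph_eq N M (rels_and (anticomm N) (poly1 N))
  \/ sph_eq N M (anticomm N).
Proof.
  intros HP HQ M.
  destruct HP as [hP|[hP|hP]], HQ as [hQ|[hQ|hQ]];
    pose proof (sph_eq_and N _ _ _ _ hP hQ) as h; fold M in h.
  - do 6 right; left. exact (sph_eq_trans _ _ _ _ h (classical_and_anticomm N)).
  - do 3 right; left. exact (sph_eq_trans _ _ _ _ h (classical_and_halflib_bar N)).
  - left. exact (sph_eq_trans _ _ _ _ h (and_free N _)).
  - do 7 right; left. exact (sph_eq_trans _ _ _ _ h (halflib_and_anticomm N)).
  - do 4 right; left. exact (sph_eq_trans _ _ _ _ h (halflib_and_halflib_bar N)).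
  - right; left. exact (sph_eq_trans _ _ _ _ h (and_free N _)).
  - do 8 right. exact (sph_eq_trans _ _ _ _ h (free_and N _)).
  - do 5 right; left. exact (sph_eq_trans _ _ _ _ h (free_and N _)).
  - do 2 right; left. exact (sph_eq_trans _ _ _ _ h (free_and N _)).
Qed.

Theorem theorem2p5 (N : nat) (HN : (3 <= N)%nat) (E F : permset)
  (HE : forall k s, E k s -> (1 <= k <= 5)%nat /\ is_perm k s)
  (HF : forall k s, F k s -> (1 <= k <= 5)%nat /\ is_perm k s) :
  (sph_eq N (S_E N E) (classical N) \/ sph_eq N (S_E N E) (halflib N)
     \/ sph_eq N (S_E N E) free_rels)
  /\ (forall k s, (1 <= k <= 5)%nat -> is_perm k s -> (exists r, (r < k)%nat /\ s r <> r) ->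
        sph_eq N (S_E N (single k s)) (classical N)
        \/ sph_eq N (S_E N (single k s)) (halflib N))
  /\ (sph_eq N (Sbar_F N F) (anticomm N) \/ sph_eq N (Sbar_F N F) (halflib_bar N)
     \/ sph_eq N (Sbar_F N F) free_rels)
  /\ (let M := rels_and (S_E N E) (Sbar_F N F) in
      sph_eq N M (classical N)
      \/ sph_eq N M (halflib N)
      \/ sph_eq N M free_rels
      \/ sph_eq N M (rels_and (classical N) (poly1 N))
      \/ sph_eq N M (rels_and (halflib N) (poly1 N))
      \/ sph_eq N M (halflib_bar N)
      \/ sph_eq N M (rels_and (classical N) (poly0 N))
      \/ sph_eq N M (rels_and (anticomm N) (poly1 N))
      \/ sph_eq N M (anticomm N)).
Proof.
  (* [3 <= N] only makes the listed spheres pairwise distinct; the classification holds for all N. *)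
  pose proof (S_E_classification N E HE) as HSE.
  pose proof (Sbar_F_classification N F HF) as HSF.
  split; [exact HSE|]. split; [exact (S_E_single_classification N)|].
  split; [exact HSF|]. exact (mixed_classification N _ _ HSE HSF).
Qed.
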